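(* The Riemannian manifold $(\mathbb{R}^2,\,e^{\,y-x^2}(dx^2+dy^2))$ admits no non-constant equilibrium function, and hence no equilibrium partition.
   Context: For a metric $h$ on $\mathbb{R}^2$, a real-analytic function $I:\mathbb{R}^2\to\mathbb{R}$ is an equilibrium function of $(\mathbb{R}^2,h)$ if $(\nabla_h I)^2$ and $\Delta_h I$ are constant on each connected component of each level set of $I$. Here $\nabla_h$ is the gradient of $h$ and $\Delta_h$ is the Laplace–Beltrami operator of $h$. *)

From Stdlib Require Import Reals.
From Coquelicot Require Import Coquelicot.
Open Scope R_scope.

Definition partial_x (f : R * R -> R) (p : R * R) : R :=
  Derive (fun t => f (t, snd p)) (fst p).
Definition partial_y (f : R * R -> R) (p : R * R) : R :=
  Derive (fun t => f (fst p, t)) (snd p).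

(* Real-analytic on R^2: near every point, f is the sum of an absolutely
   convergent double power series (partial sums over squares). *)
Definition real_analytic2 (f : R * R -> R) : Prop :=
  forall p0 : R * R, exists r : R, 0 < r /\
  exists a : nat -> nat -> R,
  forall p : R * R,
    Rabs (fst p - fst p0) < r -> Rabs (snd p - snd p0) < r ->
    (exists M : R, forall N : nat,
        sum_n (fun m => sum_n (fun n =>
          Rabs (a m n) * Rabs (fst p - fst p0) ^ m * Rabs (snd p - snd p0) ^ n) N) N
        <= M) /\
    is_lim_seq (fun N => sum_n (fun m => sum_n (fun n =>
          a m n * (fst p - fst p0) ^ m * (snd p - snd p0) ^ n) N) N) (f p).

Definition connected2 (A : R * R -> Prop) : Prop :=
  forall U V : R * R -> Prop, open U -> open V ->
    (forall z, A z -> U z \/ V z) ->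
    (forall z, ~ (A z /\ U z /\ V z)) ->
    (forall z, ~ (A z /\ U z)) \/ (forall z, ~ (A z /\ V z)).

Definition same_level_component (I : R * R -> R) (p q : R * R) : Prop :=
  exists A : R * R -> Prop,
    connected2 A /\ A p /\ A q /\ (forall z, A z -> I z = I p).

(* A Riemannian metric on R^2 given by components h = E dx^2 + 2F dx dy + G dy^2. *)
Section Metric.
Variables E F G : R * R -> R.

Definition metric_det (p : R * R) : R := E p * G p - F p ^ 2.

(* (nabla_h I)^2 = h^{ij} d_i I d_j I *)
Definition grad_norm2 (I : R * R -> R) (p : R * R) : R :=
  (G p * partial_x I p ^ 2 - 2 * F p * partial_x I p * partial_y I p
   + E p * partial_y I p ^ 2) / metric_det p.

(* Laplace-Beltrami: 1/sqrt|h| d_i (sqrt|h| h^{ij} d_j I) *)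
Definition laplace_beltrami (I : R * R -> R) (p : R * R) : R :=
  / sqrt (metric_det p) *
  ( partial_x (fun q => sqrt (metric_det q) *
        ((G q * partial_x I q - F q * partial_y I q) / metric_det q)) p
  + partial_y (fun q => sqrt (metric_det q) *
        ((- F q * partial_x I q + E q * partial_y I q) / metric_det q)) p ).

Definition equilibrium_function (I : R * R -> R) : Prop :=
  real_analytic2 I /\
  forall p q : R * R, same_level_component I p q ->
    grad_norm2 I p = grad_norm2 I q /\
    laplace_beltrami I p = laplace_beltrami I q.
End Metric.

Definition conf_factor (p : R * R) : R := exp (snd p - fst p ^ 2).
Definition zero_fun (p : R * R) : R := 0.

From Stdlib Require Import Reals Lra Lia Classical IndefiniteDescription.
From Coquelicot Require Import Coquelicot.
Open Scope R_scope.

(* With [mu = e^(x^2 - y)], the metric gives [|grad_h I|^2 = mu |grad I|^2] and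
   [Delta_h I = mu (I_xx + I_yy)]. An equilibrium function is smooth (differentiate its
   local double power series termwise), and wherever [I_y <> 0] its level components are
   locally graphs, so the constancy of [f = mu |grad I|^2] and [g = mu (I_xx + I_yy)] on
   them makes the Jacobians [I_y f_x - I_x f_y] and [I_y g_x - I_x g_y] vanish. Where both
   partials of [I] are nonzero, these identities and their first and second derivatives
   eliminate all higher derivatives of [I] and leave [I_x + 2 x I_y = 0]; substituting
   back gives [x mu I_y^3 = 0], impossible on an open set. Where [I_x] vanishes
   identically the same conclusion is immediate, and where [I_y] does, [I] and [I_x] are
   constant on a vertical segment, along which [mu I_x^2] cannot be. So [grad I = 0]. *)

(** * Finite sums and absolutely convergent double series *)

Lemma Rsum_n_S (a : nat -> R) n : sum_n a (S n) = sum_n a n + a (S n).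
Proof. now rewrite sum_Sn. Qed.

Lemma Rsum_n_O (a : nat -> R) : sum_n a 0 = a 0%nat.
Proof. now rewrite sum_O. Qed.

Lemma Rsum_n_ext (a b : nat -> R) N : (forall k, a k = b k) -> sum_n a N = sum_n b N.
Proof. apply sum_n_ext. Qed.

Lemma Rsum_n_le (a b : nat -> R) N : (forall k, a k <= b k) -> sum_n a N <= sum_n b N.
Proof.
  intro H; induction N; [rewrite !Rsum_n_O; auto|].
  rewrite !Rsum_n_S; specialize (H (S N)); lra.
Qed.

Lemma Rsum_n_nonneg (a : nat -> R) N : (forall k, 0 <= a k) -> 0 <= sum_n a N.
Proof.
  intro H; induction N; [rewrite Rsum_n_O; auto|].
  rewrite Rsum_n_S; specialize (H (S N)); lra.
Qed.

Lemma Rsum_n_incr (a : nat -> R) N N' :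
  (forall k, 0 <= a k) -> (N <= N')%nat -> sum_n a N <= sum_n a N'.
Proof.
  intros H HN; induction HN; [lra|].
  rewrite Rsum_n_S; specialize (H (S m)); lra.
Qed.

Lemma Rsum_n_term_le (a : nat -> R) k N :
  (forall k, 0 <= a k) -> (k <= N)%nat -> a k <= sum_n a N.
Proof.
  intros H HN; induction HN.
  - destruct k; [rewrite Rsum_n_O; lra|].
    rewrite Rsum_n_S; pose proof (Rsum_n_nonneg a k H); lra.
  - rewrite Rsum_n_S; specialize (H (S m)); lra.
Qed.

Lemma Rsum_n_Rabs (a : nat -> R) N : Rabs (sum_n a N) <= sum_n (fun k => Rabs (a k)) N.
Proof.
  induction N; [rewrite !Rsum_n_O; lra|].
  rewrite !Rsum_n_S; pose proof (Rabs_triang (sum_n a N) (a (S N))); lra.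
Qed.

Lemma Rsum_n_shift (a : nat -> R) N : sum_n a (S N) = a 0%nat + sum_n (fun k => a (S k)) N.
Proof.
  induction N; [rewrite Rsum_n_S, !Rsum_n_O; lra|].
  rewrite Rsum_n_S, IHN, (Rsum_n_S (fun k => a (S k))); lra.
Qed.

Lemma Rsum_n_minus (a b : nat -> R) N :
  sum_n (fun k => a k - b k) N = sum_n a N - sum_n b N.
Proof. induction N; [rewrite !Rsum_n_O; lra | rewrite !Rsum_n_S; lra]. Qed.

Lemma Rsum_n_scal (c : R) (a : nat -> R) N : sum_n (fun k => c * a k) N = c * sum_n a N.
Proof. induction N; [rewrite !Rsum_n_O; lra | rewrite !Rsum_n_S; nra]. Qed.

Lemma is_lim_seq_sum_n (f : nat -> nat -> R) (l : nat -> R) K :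
  (forall m, is_lim_seq (f m) (l m)) ->
  is_lim_seq (fun N => sum_n (fun m => f m N) K) (sum_n l K).
Proof.
  intro H. induction K.
  - rewrite Rsum_n_O. apply is_lim_seq_ext with (f 0%nat); auto.
    intro; now rewrite Rsum_n_O.
  - rewrite Rsum_n_S.
    apply is_lim_seq_ext with (fun N => sum_n (fun m => f m N) K + f (S K) N).
    + intro; now rewrite Rsum_n_S.
    + now apply is_lim_seq_plus'.
Qed.

Lemma ex_series_nonneg_bounded (a : nat -> R) M :
  (forall k, 0 <= a k) -> (forall N, sum_n a N <= M) ->
  ex_series a /\ Series a <= M /\ (forall N, sum_n a N <= Series a).
Proof.
  intros Hp HM.
  assert (Hincr : forall n, sum_n a n <= sum_n a (S n))
    by (intro n; rewrite Rsum_n_S; specialize (Hp (S n)); lra).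
  destruct (ex_finite_lim_seq_incr _ M Hincr HM) as [l HL].
  assert (HS : Series a = l) by (unfold Series; now rewrite (is_lim_seq_unique _ _ HL)).
  rewrite HS. split; [now exists l | split].
  - change (Rbar_le l M).
    apply is_lim_seq_le with (sum_n a) (fun _ => M); auto. apply is_lim_seq_const.
  - intro N. change (Rbar_le (sum_n a N) l).
    apply is_lim_seq_le_loc with (fun _ => sum_n a N) (sum_n a); auto.
    + exists N; intros n Hn; now apply Rsum_n_incr.
    + apply is_lim_seq_const.
Qed.

Lemma is_lim_seq_Series (a : nat -> R) : ex_series a -> is_lim_seq (sum_n a) (Series a).
Proof. intro H. exact (Series_correct _ H). Qed.

Lemma Series_tail_le (u b : nat -> R) N :
  ex_series u -> ex_series b -> (forall k, Rabs (u k) <= b k) ->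
  Rabs (Series u - sum_n u N) <= Series b - sum_n b N.
Proof.
  intros Hu Hb Hub.
  assert (Hu' : is_lim_seq (fun K => Rabs (sum_n u K - sum_n u N)) (Rabs (Series u - sum_n u N))).
  { apply (is_lim_seq_abs _ (Finite (Series u - sum_n u N))).
    apply is_lim_seq_minus'; [now apply is_lim_seq_Series | apply is_lim_seq_const]. }
  assert (Hb' : is_lim_seq (fun K => sum_n b K - sum_n b N) (Series b - sum_n b N)).
  { apply is_lim_seq_minus'; [now apply is_lim_seq_Series | apply is_lim_seq_const]. }
  change (Rbar_le (Rabs (Series u - sum_n u N)) (Series b - sum_n b N)).
  apply is_lim_seq_le_loc with (2 := Hu') (3 := Hb').
  exists N. intros K HK. induction HK; [rewrite !Rminus_diag, Rabs_R0; lra|].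
  rewrite !Rsum_n_S. specialize (Hub (S m)).
  pose proof (Rabs_triang (sum_n u m - sum_n u N) (u (S m))).
  replace (sum_n u m + u (S m) - sum_n u N) with (sum_n u m - sum_n u N + u (S m)) by ring.
  lra.
Qed.

Definition square_sum (c : nat -> nat -> R) N := sum_n (fun m => sum_n (fun n => c m n) N) N.

Definition iterated_series (c : nat -> nat -> R) := Series (fun m => Series (fun n => c m n)).

Lemma square_sum_swap (c : nat -> nat -> R) N : square_sum (fun m n => c n m) N = square_sum c N.
Proof. symmetry. apply (sum_n_switch (G := R_AbelianMonoid)). Qed.

Lemma rect_sum_le_square_sum (c : nat -> nat -> R) K N :
  (forall m n, 0 <= c m n) ->
  sum_n (fun m => sum_n (fun n => c m n) N) K <= square_sum c (Nat.max K N).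
Proof.
  intro Hc. unfold square_sum.
  apply Rle_trans with (sum_n (fun m => sum_n (fun n => c m n) (Nat.max K N)) K).
  - apply Rsum_n_le. intro m. apply Rsum_n_incr; auto; lia.
  - apply Rsum_n_incr; [intro m; now apply Rsum_n_nonneg | lia].
Qed.

(* If the square partial sums of [|c|] are bounded, the square partial sums of [c]
   converge to the iterated sum: they differ from it by at most the corresponding
   tail of the iterated sum of [|c|]. *)
Section AbsoluteDoubleSeries.
Variables (c : nat -> nat -> R) (M : R).
Hypothesis Hbound : forall N, square_sum (fun m n => Rabs (c m n)) N <= M.

Let row_abs m := Series (fun n => Rabs (c m n)).

Lemma rect_sum_abs_le K N : sum_n (fun m => sum_n (fun n => Rabs (c m n)) N) K <= M.
Proof.
  eapply Rle_trans; [apply rect_sum_le_square_sum | apply Hbound].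
  intros; apply Rabs_pos.
Qed.

Lemma row_abs_summable m :
  ex_series (fun n => Rabs (c m n)) /\ forall N, sum_n (fun n => Rabs (c m n)) N <= row_abs m.
Proof.
  assert (Hrow : forall N, sum_n (fun n => Rabs (c m n)) N <= M).
  { intro N. eapply Rle_trans; [|apply (rect_sum_abs_le m N)].
    apply (Rsum_n_term_le (fun m => sum_n (fun n => Rabs (c m n)) N)); auto.
    intro; apply Rsum_n_nonneg; intro; apply Rabs_pos. }
  destruct (ex_series_nonneg_bounded _ M (fun n => Rabs_pos _) Hrow) as [H [_ H']].
  now split.
Qed.

Lemma is_lim_seq_row_abs m : is_lim_seq (sum_n (fun n => Rabs (c m n))) (row_abs m).
Proof. apply is_lim_seq_Series, row_abs_summable. Qed.

Lemma row_abs_nonneg m : 0 <= row_abs m.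
Proof.
  apply Rle_trans with (sum_n (fun n => Rabs (c m n)) 0).
  - apply Rsum_n_nonneg; intro; apply Rabs_pos.
  - apply row_abs_summable.
Qed.

Lemma row_abs_summable_total :
  ex_series row_abs /\ forall N, sum_n row_abs N <= Series row_abs.
Proof.
  assert (HK : forall K, sum_n row_abs K <= M).
  { intro K. change (Rbar_le (sum_n row_abs K) M).
    apply is_lim_seq_le with (2 := is_lim_seq_sum_n _ _ K is_lim_seq_row_abs)
      (3 := is_lim_seq_const M).
    intro N; apply rect_sum_abs_le. }
  destruct (ex_series_nonneg_bounded _ M row_abs_nonneg HK) as [H [_ H']].
  now split.
Qed.

Lemma is_lim_square_sum_abs :
  is_lim_seq (square_sum (fun m n => Rabs (c m n))) (Series row_abs).
Proof.
  destruct row_abs_summable_total as [Hex Hle].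
  apply is_lim_seq_spec. intro eps.
  assert (He2 : 0 < eps / 2) by (destruct eps; simpl; lra).
  pose proof (is_lim_seq_Series _ Hex) as HA. apply is_lim_seq_spec in HA.
  destruct (HA (mkposreal _ He2)) as [K HK]. specialize (HK K (Nat.le_refl _)). simpl in HK.
  pose proof (is_lim_seq_sum_n _ _ K is_lim_seq_row_abs) as HL. apply is_lim_seq_spec in HL.
  destruct (HL (mkposreal _ He2)) as [N0 HN0]. simpl in HN0.
  exists (Nat.max K N0). intros N HN. specialize (HN0 N ltac:(lia)).
  assert (H1 : sum_n (fun m => sum_n (fun n => Rabs (c m n)) N) K
               <= square_sum (fun m n => Rabs (c m n)) N).
  { apply Rsum_n_incr; [intro; apply Rsum_n_nonneg; intro; apply Rabs_pos | lia]. }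
  assert (H2 : square_sum (fun m n => Rabs (c m n)) N <= sum_n row_abs N)
    by (apply Rsum_n_le; intro m; apply row_abs_summable).
  specialize (Hle N).
  apply Rabs_lt_between' in HK. apply Rabs_lt_between' in HN0.
  apply Rabs_lt_between'. lra.
Qed.

Lemma square_sum_dist_le N :
  Rabs (square_sum c N - iterated_series c)
  <= Series row_abs - square_sum (fun m n => Rabs (c m n)) N.
Proof.
  destruct row_abs_summable_total as [Hex _].
  set (V := fun m => Series (fun n => c m n)).
  assert (Hrow : forall m, ex_series (fun n => c m n))
    by (intro m; apply ex_series_Rabs, row_abs_summable).
  assert (HexV : ex_series V).
  { apply (ex_series_le (K := R_AbsRing) (V := R_CompleteNormedModule)) with row_abs; auto.
    intro m; apply Series_Rabs, row_abs_summable. }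
  replace (square_sum c N - iterated_series c)
    with (sum_n (fun m => sum_n (fun n => c m n) N - V m) N + (sum_n V N - Series V))
    by (unfold square_sum, iterated_series; fold V; rewrite Rsum_n_minus; ring).
  eapply Rle_trans; [apply Rabs_triang|].
  assert (E1 : Rabs (sum_n (fun m => sum_n (fun n => c m n) N - V m) N)
               <= sum_n row_abs N - square_sum (fun m n => Rabs (c m n)) N).
  { eapply Rle_trans; [apply Rsum_n_Rabs|].
    unfold square_sum. rewrite <- Rsum_n_minus.
    apply Rsum_n_le. intro m. rewrite Rabs_minus_sym.
    apply Series_tail_le; [apply Hrow | apply row_abs_summable | intro; apply Rle_refl]. }
  assert (E2 : Rabs (sum_n V N - Series V) <= Series row_abs - sum_n row_abs N).
  { rewrite Rabs_minus_sym. apply Series_tail_le; auto.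
    intro m; apply Series_Rabs, row_abs_summable. }
  lra.
Qed.

Lemma is_lim_square_sum : is_lim_seq (square_sum c) (iterated_series c).
Proof.
  apply is_lim_seq_spec. intro eps.
  pose proof is_lim_square_sum_abs as HS. apply is_lim_seq_spec in HS.
  destruct (HS eps) as [N0 HN0]. exists N0. intros N HN.
  specialize (HN0 N HN). apply Rabs_lt_between' in HN0.
  eapply Rle_lt_trans; [apply square_sum_dist_le | lra].
Qed.

Lemma iterated_series_Rabs_le : Rabs (iterated_series c) <= M.
Proof.
  change (Rbar_le (Rabs (iterated_series c)) M).
  apply is_lim_seq_le with (2 := is_lim_seq_abs _ _ is_lim_square_sum)
    (3 := is_lim_seq_const M).
  intro N. eapply Rle_trans; [|apply (Hbound N)]. unfold square_sum.
  eapply Rle_trans; [apply Rsum_n_Rabs | apply Rsum_n_le; intro m; apply Rsum_n_Rabs].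
Qed.

End AbsoluteDoubleSeries.

Lemma iterated_series_swap (c : nat -> nat -> R) M :
  (forall N, square_sum (fun m n => Rabs (c m n)) N <= M) ->
  iterated_series c = iterated_series (fun m n => c n m).
Proof.
  intro Hb.
  assert (Hb' : forall N, square_sum (fun m n => Rabs (c n m)) N <= M)
    by (intro N; rewrite (square_sum_swap (fun m n => Rabs (c m n))); apply Hb).
  pose proof (is_lim_square_sum _ _ Hb) as H1.
  pose proof (is_lim_square_sum _ _ Hb') as H2.
  apply is_lim_seq_ext with (v := square_sum c) in H2; [|intro; apply square_sum_swap].
  apply is_lim_seq_unique in H1. apply is_lim_seq_unique in H2.
  rewrite H1 in H2. now injection H2.
Qed.

(** * Double power series *)

Lemma continuity_pt_of_is_derive (f : R -> R) x l : is_derive f x l -> continuity_pt f x.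
Proof.
  intro H. apply continuity_pt_filterlim.
  apply (ex_derive_continuous (K := R_AbsRing) (V := R_NormedModule)). now exists l.
Qed.

Lemma MVT_is_derive (f df : R -> R) a b :
  (forall t, Rmin a b <= t <= Rmax a b -> is_derive f t (df t)) ->
  exists c, Rmin a b <= c <= Rmax a b /\ f b - f a = df c * (b - a).
Proof.
  intro H. apply MVT_gen.
  - intros t Ht. apply H; lra.
  - intros t Ht. apply (continuity_pt_of_is_derive f t (df t)), H, Ht.
Qed.

Lemma iterated_series_ext (c d : nat -> nat -> R) :
  (forall m n, c m n = d m n) -> iterated_series c = iterated_series d.
Proof.
  intro H. unfold iterated_series. apply Series_ext. intro m. apply Series_ext. auto.
Qed.

Lemma pow_Rabs_le X rho k : Rabs X <= rho -> Rabs (X ^ k) <= rho ^ k.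
Proof. intro H. rewrite <- RPow_abs. apply pow_incr. split; auto. apply Rabs_pos. Qed.

Definition ps2 (a : nat -> nat -> R) (X Y : R) :=
  iterated_series (fun m n => a m n * X ^ m * Y ^ n).

Definition ps2_bounded_at (a : nat -> nat -> R) (rho : R) :=
  exists M, forall N, square_sum (fun m n => Rabs (a m n) * rho ^ m * rho ^ n) N <= M.

Definition ps2_abs_conv (a : nat -> nat -> R) (r : R) :=
  forall rho, 0 <= rho < r -> ps2_bounded_at a rho.

Definition coef_dx (a : nat -> nat -> R) m n := INR (S m) * a (S m) n.

Definition coef_dy (a : nat -> nat -> R) m n := INR (S n) * a m (S n).

Definition coef_swap (a : nat -> nat -> R) m n := a n m.

Lemma ps2_ext a b X Y : (forall m n, a m n = b m n) -> ps2 a X Y = ps2 b X Y.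
Proof. intro H. apply iterated_series_ext. intros. now rewrite H. Qed.

Lemma ps2_majorant_nonneg a rho :
  0 <= rho -> forall m n, 0 <= Rabs (a m n) * rho ^ m * rho ^ n.
Proof.
  intros. repeat apply Rmult_le_pos; try apply pow_le; auto. apply Rabs_pos.
Qed.

Lemma square_sum_ps2_terms_le a rho X Y M :
  Rabs X <= rho -> Rabs Y <= rho ->
  (forall N, square_sum (fun m n => Rabs (a m n) * rho ^ m * rho ^ n) N <= M) ->
  forall N, square_sum (fun m n => Rabs (a m n * X ^ m * Y ^ n)) N <= M.
Proof.
  intros HX HY H N. eapply Rle_trans; [|apply (H N)].
  apply Rsum_n_le; intro m. apply Rsum_n_le; intro n.
  rewrite !Rabs_mult.
  pose proof (pow_Rabs_le X rho m HX). pose proof (pow_Rabs_le Y rho n HY).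
  apply Rmult_le_compat; try apply Rabs_pos.
  - apply Rmult_le_pos; apply Rabs_pos.
  - apply Rmult_le_compat_l; auto. apply Rabs_pos.
  - auto.
Qed.

Lemma ps2_Rabs_le a rho X Y M :
  Rabs X <= rho -> Rabs Y <= rho ->
  (forall N, square_sum (fun m n => Rabs (a m n) * rho ^ m * rho ^ n) N <= M) ->
  Rabs (ps2 a X Y) <= M.
Proof.
  intros HX HY H.
  exact (iterated_series_Rabs_le _ _ (square_sum_ps2_terms_le a rho X Y M HX HY H)).
Qed.

Lemma row_sum_le_square_bound (c : nat -> nat -> R) M m N :
  (forall m n, 0 <= c m n) -> (forall N, square_sum c N <= M) ->
  sum_n (fun n => c m n) N <= M.
Proof.
  intros Hp Hb. eapply Rle_trans; [|apply (Hb (Nat.max m N))].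
  eapply Rle_trans; [|apply rect_sum_le_square_sum; auto].
  apply (Rsum_n_term_le (fun m => sum_n (fun n => c m n) N)); [|lia].
  intro; apply Rsum_n_nonneg; auto.
Qed.

(* Bernoulli's inequality [(1+h)^m >= 1 + m h] with [rho' = rho (1+h)]. *)

Lemma succ_pow_le_geometric rho rho' :
  0 <= rho < rho' -> exists C, 0 <= C /\ forall m, INR (S m) * rho ^ m <= C * rho' ^ (S m).
Proof.
  intros [H0 H1].
  destruct (Req_dec rho 0) as [E|E].
  - exists (/ rho'). split; [left; apply Rinv_0_lt_compat; lra|].
    intro m. subst. destruct m; [simpl; field_simplify; lra|].
    rewrite pow_i by lia. rewrite Rmult_0_r.
    apply Rmult_le_pos; [left; apply Rinv_0_lt_compat; lra | apply pow_le; lra].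
  - set (h := rho' / rho - 1).
    assert (Hh : 0 < h).
    { unfold h. replace (rho' / rho - 1) with ((rho' - rho) / rho) by (field; lra).
      apply Rdiv_lt_0_compat; lra. }
    assert (Hih : 0 < / h) by (apply Rinv_0_lt_compat; lra).
    exists ((1 + / h) / rho'). split.
    { apply Rmult_le_pos; [lra | left; apply Rinv_0_lt_compat; lra]. }
    intro m.
    assert (Er : rho' = rho * (1 + h)) by (unfold h; field; lra).
    rewrite <- tech_pow_Rmult.
    replace ((1 + / h) / rho' * (rho' * rho' ^ m)) with ((1 + / h) * rho' ^ m) by (field; lra).
    rewrite Er, Rpow_mult_distr.
    assert (Hp : 0 < rho ^ m) by (apply pow_lt; lra).
    rewrite (Rmult_comm (rho ^ m)), <- Rmult_assoc. apply Rmult_le_compat_r; [lra|].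
    rewrite S_INR.
    assert (INR m + 1 <= (1 + / h) * (1 + INR m * h)).
    { pose proof (pos_INR m).
      replace ((1 + / h) * (1 + INR m * h)) with (1 + INR m * h + / h + INR m) by (field; lra).
      nra. }
    apply Rle_trans with ((1 + / h) * (1 + INR m * h)); auto.
    apply Rmult_le_compat_l; [lra | apply Rle_pow_lin; lra].
Qed.

Lemma ps2_abs_conv_dx a r : ps2_abs_conv a r -> ps2_abs_conv (coef_dx a) r.
Proof.
  intros H rho Hr.
  set (rho' := (rho + r) / 2).
  destruct (H rho' ltac:(unfold rho'; lra)) as [M HM].
  destruct (succ_pow_le_geometric rho rho') as [C [HC0 HC]]; [unfold rho'; lra|].
  exists (C * M). intro N.
  set (g := fun m n => Rabs (a m n) * rho' ^ m * rho' ^ n).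
  assert (Hg : forall m n, 0 <= g m n) by (intros; apply ps2_majorant_nonneg; unfold rho'; lra).
  apply Rle_trans with (sum_n (fun m => sum_n (fun n => C * g (S m) n) N) N).
  - apply Rsum_n_le; intro m; apply Rsum_n_le; intro n. unfold coef_dx, g.
    rewrite Rabs_mult, Rabs_pos_eq by apply pos_INR.
    specialize (HC m).
    assert (rho ^ n <= rho' ^ n) by (apply pow_incr; unfold rho'; lra).
    assert (0 <= rho ^ n) by (apply pow_le; lra).
    pose proof (Rabs_pos (a (S m) n)).
    assert (0 <= INR (S m) * rho ^ m) by (apply Rmult_le_pos; [apply pos_INR | apply pow_le; lra]).
    apply Rle_trans with ((INR (S m) * rho ^ m) * Rabs (a (S m) n) * rho ^ n); [right; ring|].
    apply Rle_trans with ((C * rho' ^ (S m)) * Rabs (a (S m) n) * rho' ^ n); [|right; ring].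
    apply Rmult_le_compat; auto. apply Rmult_le_pos; auto.
    apply Rmult_le_compat_r; auto.
  - rewrite (Rsum_n_ext _ (fun m => C * sum_n (fun n => g (S m) n) N))
      by (intro; apply Rsum_n_scal).
    rewrite Rsum_n_scal. apply Rmult_le_compat_l; auto.
    apply Rle_trans with (sum_n (fun m => sum_n (fun n => g m n) N) (S N)).
    + rewrite Rsum_n_shift.
      assert (0 <= sum_n (fun n => g 0%nat n) N) by (apply Rsum_n_nonneg; auto).
      lra.
    + eapply Rle_trans; [|apply (HM (S N))]. unfold square_sum. fold g.
      apply Rsum_n_le. intro m. apply Rsum_n_incr; [intro; apply Hg | lia].
Qed.

Lemma ps2_abs_conv_swap a r : ps2_abs_conv a r -> ps2_abs_conv (coef_swap a) r.
Proof.
  intros H rho Hr. destruct (H rho Hr) as [M HM]. exists M. intro N.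
  rewrite <- square_sum_swap. eapply Rle_trans; [|apply (HM N)]. right.
  unfold square_sum, coef_swap.
  apply Rsum_n_ext; intro; apply Rsum_n_ext; intro; ring.
Qed.

Lemma ps2_abs_conv_dy a r : ps2_abs_conv a r -> ps2_abs_conv (coef_dy a) r.
Proof.
  intro H. exact (ps2_abs_conv_swap _ _ (ps2_abs_conv_dx _ _ (ps2_abs_conv_swap _ _ H))).
Qed.

Lemma ps2_swap a r X Y :
  ps2_abs_conv a r -> Rabs X < r -> Rabs Y < r -> ps2 a X Y = ps2 (coef_swap a) Y X.
Proof.
  intros H HX HY.
  set (rho := Rmax (Rabs X) (Rabs Y)).
  assert (Hr : 0 <= rho < r).
  { split; [apply Rle_trans with (Rabs X); [apply Rabs_pos | apply Rmax_l]|].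
    now apply Rmax_lub_lt. }
  destruct (H rho Hr) as [M HM].
  unfold ps2. rewrite (iterated_series_swap _ M).
  - apply iterated_series_ext. intros; unfold coef_swap; ring.
  - apply square_sum_ps2_terms_le with rho; auto; [apply Rmax_l | apply Rmax_r].
Qed.

(* For fixed [Y], [ps2 a _ Y] is the one-variable power series with coefficients
   [b m = sum_n a_mn Y^n], and [b m rho^m] stays bounded. *)

Lemma ps2_row_coef_bounded a rho Y M m :
  0 < rho -> Rabs Y <= rho ->
  (forall N, square_sum (fun m n => Rabs (a m n) * rho ^ m * rho ^ n) N <= M) ->
  Rabs (Series (fun n => a m n * Y ^ n) * rho ^ m) <= M.
Proof.
  intros Hr HY HM.
  assert (Hrm : 0 < rho ^ m) by (apply pow_lt; lra).
  assert (Hrow : forall N, sum_n (fun n => Rabs (a m n) * rho ^ m * rho ^ n) N <= M).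
  { intro N. apply (row_sum_le_square_bound (fun m n => Rabs (a m n) * rho ^ m * rho ^ n)); auto.
    apply ps2_majorant_nonneg; lra. }
  assert (Hterm : forall N,
    sum_n (fun n => Rabs (a m n * Y ^ n)) N * rho ^ m <= M).
  { intro N. eapply Rle_trans; [|apply (Hrow N)].
    rewrite Rmult_comm, <- Rsum_n_scal. apply Rsum_n_le. intro n.
    rewrite Rabs_mult. pose proof (pow_Rabs_le Y rho n HY). pose proof (Rabs_pos (a m n)).
    apply Rle_trans with (rho ^ m * (Rabs (a m n) * rho ^ n)); [|right; ring].
    apply Rmult_le_compat_l; [lra | now apply Rmult_le_compat_l]. }
  assert (Hex : ex_series (fun n => a m n * Y ^ n)).
  { apply ex_series_Rabs.
    apply (ex_series_nonneg_bounded _ (M / rho ^ m)); [intro; apply Rabs_pos|].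
    intro N. apply Rmult_le_reg_r with (rho ^ m); auto.
    unfold Rdiv. rewrite Rmult_assoc, Rinv_l, Rmult_1_r by lra. apply Hterm. }
  change (Rbar_le (Rabs (Series (fun n => a m n * Y ^ n) * rho ^ m)) M).
  apply is_lim_seq_le with (fun N => Rabs (sum_n (fun n => a m n * Y ^ n) N * rho ^ m))
    (fun _ => M).
  - intro N. eapply Rle_trans; [|apply (Hterm N)].
    rewrite Rabs_mult, (Rabs_pos_eq (rho ^ m)) by lra.
    apply Rmult_le_compat_r; [lra | apply Rsum_n_Rabs].
  - apply (is_lim_seq_abs _ (Finite (Series (fun n => a m n * Y ^ n) * rho ^ m))).
    apply is_lim_seq_mult'; [now apply is_lim_seq_Series | apply is_lim_seq_const].
  - apply is_lim_seq_const.
Qed.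

Lemma is_derive_ps2_x a r X Y :
  ps2_abs_conv a r -> Rabs X < r -> Rabs Y < r ->
  is_derive (fun t => ps2 a t Y) X (ps2 (coef_dx a) X Y).
Proof.
  intros H HX HY.
  set (rho := (Rmax (Rabs X) (Rabs Y) + r) / 2).
  assert (Hmx : Rmax (Rabs X) (Rabs Y) < r) by now apply Rmax_lub_lt.
  assert (HXr : Rabs X < rho) by (unfold rho; pose proof (Rmax_l (Rabs X) (Rabs Y)); lra).
  assert (HYr : Rabs Y < rho) by (unfold rho; pose proof (Rmax_r (Rabs X) (Rabs Y)); lra).
  assert (Hr : 0 <= rho < r) by (pose proof (Rabs_pos X); unfold rho in *; lra).
  destruct (H rho Hr) as [M HM].
  set (b := fun m => Series (fun n => a m n * Y ^ n)).
  assert (HCV : Rbar_lt (Rabs X) (CV_radius b)).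
  { apply Rbar_lt_le_trans with (Finite rho); [exact HXr|].
    apply (proj1 (CV_radius_bounded b)). exists M. intro m.
    apply ps2_row_coef_bounded; auto; pose proof (Rabs_pos X); lra. }
  apply is_derive_ext with (PSeries b).
  { intro t. unfold PSeries, ps2, iterated_series, b. apply Series_ext. intro m.
    rewrite <- Series_scal_r. apply Series_ext. intro n. ring. }
  replace (ps2 (coef_dx a) X Y) with (PSeries (PS_derive b) X).
  { exact (is_derive_PSeries b X HCV). }
  unfold PSeries, PS_derive, ps2, iterated_series, b, coef_dx. apply Series_ext. intro m.
  rewrite <- Series_scal_l, <- Series_scal_r. apply Series_ext. intro n. ring.
Qed.

Lemma is_derive_ps2_y a r X Y :
  ps2_abs_conv a r -> Rabs X < r -> Rabs Y < r ->
  is_derive (fun t => ps2 a X t) Y (ps2 (coef_dy a) X Y).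
Proof.
  intros H HX HY.
  apply is_derive_ext_loc with (fun t => ps2 (coef_swap a) t X).
  { exists (mkposreal (r - Rabs Y) ltac:(lra)). intros t Ht.
    symmetry. apply ps2_swap with r; auto.
    unfold ball in Ht; simpl in Ht. unfold AbsRing_ball, abs, minus, plus, opp in Ht; simpl in Ht.
    pose proof (Rabs_triang_inv t Y). unfold Rminus in *. lra. }
  rewrite (ps2_swap (coef_dy a) r X Y) by (try apply ps2_abs_conv_dy; auto).
  exact (is_derive_ps2_x _ r Y X (ps2_abs_conv_swap _ _ H) HY HX).
Qed.

Lemma continuous_box_iff (F : R * R -> R) (p : R * R) :
  continuous F p <->
  forall eps, 0 < eps -> exists d, 0 < d /\ forall q,
    Rabs (fst q - fst p) < d -> Rabs (snd q - snd p) < d -> Rabs (F q - F p) < eps.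
Proof.
  split.
  - intros H eps He.
    destruct (H (ball (F p) (mkposreal eps He)) (locally_ball _ _)) as [d Hd].
    exists d. split; [apply cond_pos|]. intros q H1 H2. apply (Hd q). now split.
  - intros H P [eps HP]. destruct (H eps (cond_pos eps)) as [d [Hd Hq]].
    exists (mkposreal d Hd). intros q [H1 H2]. apply HP. exact (Hq q H1 H2).
Qed.

Lemma Rabs_lt_of_between s u v rho :
  Rmin u v <= s <= Rmax u v -> Rabs u < rho -> Rabs v < rho -> Rabs s < rho.
Proof.
  intros Hs Hu Hv. apply Rabs_lt_between in Hu. apply Rabs_lt_between in Hv.
  apply Rabs_lt_between. unfold Rmin, Rmax in Hs. destruct (Rle_dec u v); lra.
Qed.

Lemma ps2_lipschitz a r rho Mx My X Y X' Y' :
  ps2_abs_conv a r -> rho < r ->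
  (forall N, square_sum (fun m n => Rabs (coef_dx a m n) * rho ^ m * rho ^ n) N <= Mx) ->
  (forall N, square_sum (fun m n => Rabs (coef_dy a m n) * rho ^ m * rho ^ n) N <= My) ->
  Rabs X < rho -> Rabs Y < rho -> Rabs X' < rho -> Rabs Y' < rho ->
  Rabs (ps2 a X' Y' - ps2 a X Y) <= Mx * Rabs (X' - X) + My * Rabs (Y' - Y).
Proof.
  intros H Hr HMx HMy HXr HYr HX' HY'.
  destruct (MVT_is_derive (fun t => ps2 a t Y') (fun t => ps2 (coef_dx a) t Y') X X')
    as [c1 [Hc1 E1]].
  { intros t Ht. pose proof (Rabs_lt_of_between _ _ _ _ Ht HXr HX').
    apply is_derive_ps2_x with r; auto; lra. }
  destruct (MVT_is_derive (fun t => ps2 a X t) (fun t => ps2 (coef_dy a) X t) Y Y')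
    as [c2 [Hc2 E2]].
  { intros t Ht. pose proof (Rabs_lt_of_between _ _ _ _ Ht HYr HY').
    apply is_derive_ps2_y with r; auto; lra. }
  assert (B1 : Rabs (ps2 (coef_dx a) c1 Y') <= Mx).
  { apply ps2_Rabs_le with rho; auto; [|lra].
    pose proof (Rabs_lt_of_between _ _ _ _ Hc1 HXr HX'); lra. }
  assert (B2 : Rabs (ps2 (coef_dy a) X c2) <= My).
  { apply ps2_Rabs_le with rho; auto; [lra|].
    pose proof (Rabs_lt_of_between _ _ _ _ Hc2 HYr HY'); lra. }
  replace (ps2 a X' Y' - ps2 a X Y) with ((ps2 a X' Y' - ps2 a X Y') + (ps2 a X Y' - ps2 a X Y))
    by ring.
  rewrite E1, E2. eapply Rle_trans; [apply Rabs_triang|]. rewrite !Rabs_mult.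
  apply Rplus_le_compat; apply Rmult_le_compat_r; auto; apply Rabs_pos.
Qed.

Lemma ps2_continuous a r X Y :
  ps2_abs_conv a r -> Rabs X < r -> Rabs Y < r ->
  continuous (fun q => ps2 a (fst q) (snd q)) (X, Y).
Proof.
  intros H HX HY. apply continuous_box_iff. intros eps He. cbn [fst snd].
  set (m0 := Rmax (Rabs X) (Rabs Y)).
  assert (Hm0 : m0 < r) by now apply Rmax_lub_lt.
  assert (HXm := Rmax_l (Rabs X) (Rabs Y)). assert (HYm := Rmax_r (Rabs X) (Rabs Y)).
  fold m0 in HXm, HYm.
  set (rho := (m0 + r) / 2).
  assert (Hr : 0 <= rho < r) by (pose proof (Rabs_pos X); unfold rho; lra).
  destruct (ps2_abs_conv_dx _ _ H rho Hr) as [Mx HMx].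
  destruct (ps2_abs_conv_dy _ _ H rho Hr) as [My HMy].
  assert (HMx0 : 0 <= Mx).
  { eapply Rle_trans; [|apply (HMx 0%nat)].
    apply Rsum_n_nonneg; intro; apply Rsum_n_nonneg; intro; apply ps2_majorant_nonneg; lra. }
  assert (HMy0 : 0 <= My).
  { eapply Rle_trans; [|apply (HMy 0%nat)].
    apply Rsum_n_nonneg; intro; apply Rsum_n_nonneg; intro; apply ps2_majorant_nonneg; lra. }
  set (del := Rmin (rho - m0) (eps / (Mx + My + 1))).
  assert (Hdr : del <= rho - m0) by apply Rmin_l.
  assert (Hde : del <= eps / (Mx + My + 1)) by apply Rmin_r.
  assert (Hd : 0 < del) by (apply Rmin_pos; [unfold rho; lra | apply Rdiv_lt_0_compat; lra]).
  exists del. split; [exact Hd|]. intros [X' Y']. cbn [fst snd]. intros H1 H2.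
  eapply Rle_lt_trans.
  { apply ps2_lipschitz with r rho; try lra; auto;
      [pose proof (Rabs_triang_inv X' X) | pose proof (Rabs_triang_inv Y' Y)]; lra. }
  assert ((Mx + My) * del < eps).
  { apply Rle_lt_trans with ((Mx + My) * (eps / (Mx + My + 1))); [apply Rmult_le_compat_l; lra|].
    assert (0 < eps / (Mx + My + 1)) by (apply Rdiv_lt_0_compat; lra).
    assert (eps / (Mx + My + 1) * (Mx + My + 1) = eps) by (field; lra).
    nra. }
  assert (Mx * Rabs (X' - X) <= Mx * del) by (apply Rmult_le_compat_l; lra).
  assert (My * Rabs (Y' - Y) <= My * del) by (apply Rmult_le_compat_l; lra).
  lra.
Qed.

(** * Partial derivatives of real-analytic functions *)

Lemma is_derive_Rplus (f g : R -> R) x a b :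
  is_derive f x a -> is_derive g x b -> is_derive (fun t => f t + g t) x (a + b).
Proof. apply (is_derive_plus (K := R_AbsRing) (V := R_NormedModule)). Qed.

Lemma is_derive_Rmult (f g : R -> R) x a b :
  is_derive f x a -> is_derive g x b -> is_derive (fun t => f t * g t) x (a * g x + f x * b).
Proof. intros H1 H2. apply (is_derive_mult f g x a b H1 H2). intros; apply Rmult_comm. Qed.

Lemma is_derive_Rconst (c x : R) : is_derive (fun _ => c) x 0.
Proof. apply (is_derive_const (K := R_AbsRing) (V := R_NormedModule)). Qed.

Lemma is_derive_translate (g : R -> R) c y l :
  is_derive g (y - c) l -> is_derive (fun t => g (t - c)) y l.
Proof.
  intro H.
  assert (H1 : is_derive (fun t => t - c) y 1)
    by (auto_derive; [exact I | ring]).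
  pose proof (is_derive_comp g (fun t => t - c) y l 1 H H1) as H2.
  simpl in H2. now rewrite (scal_one (K := R_AbsRing) (V := R_NormedModule)) in H2.
Qed.

Definition in_box (p0 : R * R) (r : R) (q : R * R) :=
  Rabs (fst q - fst p0) < r /\ Rabs (snd q - snd p0) < r.

Lemma in_box_center p r : 0 < r -> in_box p r p.
Proof. intro Hr. split; rewrite Rminus_diag, Rabs_R0; lra. Qed.

Lemma in_box_open p0 r q :
  in_box p0 r q -> exists e, 0 < e /\ forall q', in_box q e q' -> in_box p0 r q'.
Proof.
  intros [H1 H2].
  exists (Rmin (r - Rabs (fst q - fst p0)) (r - Rabs (snd q - snd p0))).
  split; [apply Rmin_pos; lra|].
  intros q' [H3 H4].
  pose proof (Rmin_l (r - Rabs (fst q - fst p0)) (r - Rabs (snd q - snd p0))).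
  pose proof (Rmin_r (r - Rabs (fst q - fst p0)) (r - Rabs (snd q - snd p0))).
  split.
  - replace (fst q' - fst p0) with ((fst q' - fst q) + (fst q - fst p0)) by ring.
    eapply Rle_lt_trans; [apply Rabs_triang | lra].
  - replace (snd q' - snd p0) with ((snd q' - snd q) + (snd q - snd p0)) by ring.
    eapply Rle_lt_trans; [apply Rabs_triang | lra].
Qed.

Section Ps2Representation.
Variables (F : R * R -> R) (a : nat -> nat -> R) (p0 : R * R) (r : R).
Hypothesis Ha : ps2_abs_conv a r.
Hypothesis HF : forall q, in_box p0 r q -> F q = ps2 a (fst q - fst p0) (snd q - snd p0).

Lemma is_derive_x_of_ps2 q : in_box p0 r q ->
  is_derive (fun t => F (t, snd q)) (fst q) (ps2 (coef_dx a) (fst q - fst p0) (snd q - snd p0)).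
Proof.
  intro Hq. destruct (in_box_open _ _ _ Hq) as [e [He He']].
  apply (is_derive_ext_loc (fun t => ps2 a (t - fst p0) (snd q - snd p0))).
  { exists (mkposreal e He). intros t Ht. symmetry. apply (HF (t, snd q)), He'.
    split; [exact Ht | cbn; rewrite Rminus_diag, Rabs_R0; lra]. }
  apply (is_derive_translate (fun s => ps2 a s (snd q - snd p0))).
  exact (is_derive_ps2_x a r _ _ Ha (proj1 Hq) (proj2 Hq)).
Qed.

Lemma is_derive_y_of_ps2 q : in_box p0 r q ->
  is_derive (fun t => F (fst q, t)) (snd q) (ps2 (coef_dy a) (fst q - fst p0) (snd q - snd p0)).
Proof.
  intro Hq. destruct (in_box_open _ _ _ Hq) as [e [He He']].
  apply (is_derive_ext_loc (fun t => ps2 a (fst q - fst p0) (t - snd p0))).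
  { exists (mkposreal e He). intros t Ht. symmetry. apply (HF (fst q, t)), He'.
    split; [cbn; rewrite Rminus_diag, Rabs_R0; lra | exact Ht]. }
  apply (is_derive_translate (fun s => ps2 a (fst q - fst p0) s)).
  exact (is_derive_ps2_y a r _ _ Ha (proj1 Hq) (proj2 Hq)).
Qed.

End Ps2Representation.

Definition pderiv (I : R * R -> R) (i j : nat) : R * R -> R :=
  Nat.iter i partial_x (Nat.iter j partial_y I).

Definition coef_D (a : nat -> nat -> R) (i j : nat) := Nat.iter i coef_dx (Nat.iter j coef_dy a).

Lemma ps2_abs_conv_D a r i j : ps2_abs_conv a r -> ps2_abs_conv (coef_D a i j) r.
Proof.
  intro H. unfold coef_D. induction i; simpl.
  - induction j; simpl; auto. now apply ps2_abs_conv_dy.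
  - now apply ps2_abs_conv_dx.
Qed.

Lemma coef_dy_D a i j m n : coef_dy (coef_D a i j) m n = coef_D a i (S j) m n.
Proof.
  revert m n. unfold coef_D. induction i; intros m n; [reflexivity|].
  change (INR (S n) * (INR (S m) * Nat.iter i coef_dx (Nat.iter j coef_dy a) (S m) (S n))
          = INR (S m) * Nat.iter i coef_dx (Nat.iter (S j) coef_dy a) (S m) n).
  rewrite <- IHi. unfold coef_dy at 2. ring.
Qed.

Lemma real_analytic2_local_ps2 I : real_analytic2 I -> forall p0, exists r a,
  0 < r /\ ps2_abs_conv a r /\
  forall q, in_box p0 r q -> I q = ps2 a (fst q - fst p0) (snd q - snd p0).
Proof.
  intros HI p0. destruct (HI p0) as [r [Hr [a Ha]]].
  exists r, a. split; [exact Hr | split].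
  - intros rho Hrho.
    assert (Hd : forall z, z + rho - z = rho) by (intro; ring).
    destruct (Ha (fst p0 + rho, snd p0 + rho)) as [[M HM] _];
      [cbn; rewrite Hd, Rabs_pos_eq; lra .. |].
    exists M. intro N. eapply Rle_trans; [|apply (HM N)]. right. unfold square_sum.
    apply Rsum_n_ext; intro m; apply Rsum_n_ext; intro n. cbn.
    now rewrite !Hd, (Rabs_pos_eq rho) by lra.
  - intros q [H1 H2]. destruct (Ha q H1 H2) as [[M HM] HL].
    set (c := fun m n => a m n * (fst q - fst p0) ^ m * (snd q - snd p0) ^ n).
    assert (Hb : forall N, square_sum (fun m n => Rabs (c m n)) N <= M).
    { intro N. eapply Rle_trans; [|apply (HM N)]. right. unfold square_sum, c.
      apply Rsum_n_ext; intro m; apply Rsum_n_ext; intro n. now rewrite !Rabs_mult, <- !RPow_abs. }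
    pose proof (is_lim_square_sum c M Hb) as HL2.
    apply is_lim_seq_unique in HL. apply is_lim_seq_unique in HL2.
    unfold square_sum, c in HL2. rewrite HL in HL2. now injection HL2.
Qed.

Lemma pderiv_ps2 I p0 r a : ps2_abs_conv a r ->
  (forall q, in_box p0 r q -> I q = ps2 a (fst q - fst p0) (snd q - snd p0)) ->
  forall i j q, in_box p0 r q ->
  pderiv I i j q = ps2 (coef_D a i j) (fst q - fst p0) (snd q - snd p0).
Proof.
  intros Ha HI.
  assert (Hj : forall j q, in_box p0 r q ->
                 pderiv I 0 j q = ps2 (coef_D a 0 j) (fst q - fst p0) (snd q - snd p0)).
  { induction j; intros q Hq; [exact (HI q Hq)|].
    apply is_derive_unique.
    exact (is_derive_y_of_ps2 _ _ p0 r (ps2_abs_conv_D a r 0 j Ha) IHj q Hq). }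
  induction i; intros j q Hq; [now apply Hj|].
  apply is_derive_unique.
  exact (is_derive_x_of_ps2 _ _ p0 r (ps2_abs_conv_D a r i j Ha) (IHi j) q Hq).
Qed.

Section AnalyticPartials.
Variable I : R * R -> R.
Hypothesis HI : real_analytic2 I.

Lemma is_derive_pderiv_x i j p :
  is_derive (fun t => pderiv I i j (t, snd p)) (fst p) (pderiv I (S i) j p).
Proof.
  destruct (real_analytic2_local_ps2 I HI p) as [r [a [Hr [Ha Hrep]]]].
  rewrite (pderiv_ps2 I p r a Ha Hrep (S i) j p (in_box_center p r Hr)).
  exact (is_derive_x_of_ps2 _ _ p r (ps2_abs_conv_D a r i j Ha)
           (pderiv_ps2 I p r a Ha Hrep i j) p (in_box_center p r Hr)).
Qed.

Lemma is_derive_pderiv_y i j p :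
  is_derive (fun t => pderiv I i j (fst p, t)) (snd p) (pderiv I i (S j) p).
Proof.
  destruct (real_analytic2_local_ps2 I HI p) as [r [a [Hr [Ha Hrep]]]].
  rewrite (pderiv_ps2 I p r a Ha Hrep i (S j) p (in_box_center p r Hr)).
  rewrite <- (ps2_ext _ _ _ _ (coef_dy_D a i j)).
  exact (is_derive_y_of_ps2 _ _ p r (ps2_abs_conv_D a r i j Ha)
           (pderiv_ps2 I p r a Ha Hrep i j) p (in_box_center p r Hr)).
Qed.

Lemma continuous_pderiv i j (p : R * R) : continuous (pderiv I i j) p.
Proof.
  destruct (real_analytic2_local_ps2 I HI p) as [r [a [Hr [Ha Hrep]]]].
  pose proof (in_box_center p r Hr) as Hp.
  apply continuous_box_iff. intros eps He.
  assert (H0 : Rabs 0 < r) by (rewrite Rabs_R0; lra).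
  destruct (proj1 (continuous_box_iff _ _) (ps2_continuous (coef_D a i j) r 0 0
             (ps2_abs_conv_D a r i j Ha) H0 H0) eps He) as [d [Hd Hc]].
  destruct (in_box_open _ _ _ Hp) as [e [He0 He']].
  exists (Rmin d e). split; [now apply Rmin_pos|].
  intros q H1 H2. pose proof (Rmin_l d e). pose proof (Rmin_r d e).
  rewrite (pderiv_ps2 I p r a Ha Hrep i j q) by (apply He'; unfold in_box; split; lra).
  rewrite (pderiv_ps2 I p r a Ha Hrep i j p Hp), !Rminus_diag.
  apply (Hc (fst q - fst p, snd q - snd p)); cbn; rewrite Rminus_0_r; lra.
Qed.

End AnalyticPartials.

(** * Differential polynomials *)

Lemma continuous_Rplus2 (F G : R * R -> R) (p : R * R) :
  continuous F p -> continuous G p -> continuous (fun q => F q + G q) p.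
Proof. apply (continuous_plus (V := R_NormedModule)). Qed.

Lemma continuous_Rmult2 (F G : R * R -> R) (p : R * R) :
  continuous F p -> continuous G p -> continuous (fun q => F q * G q) p.
Proof. apply (continuous_mult (K := R_AbsRing)). Qed.

Definition mu (p : R * R) := exp (fst p ^ 2 - snd p).

Lemma conf_factor_mu p : conf_factor p * mu p = 1.
Proof.
  unfold conf_factor, mu. rewrite <- exp_plus, <- exp_0. f_equal. ring.
Qed.

Lemma continuous_mu (p : R * R) : continuous mu p.
Proof.
  destruct p as [x y]. unfold mu.
  apply (continuous_comp (fun q : R * R => fst q ^ 2 - snd q) exp); [|apply continuous_exp].
  apply (continuous_Rplus2 (fun q => fst q ^ 2) (fun q => - snd q)).
  - apply (continuous_Rmult2 fst (fun q => fst q ^ 1)); [apply continuous_fst|].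
    apply (continuous_Rmult2 fst (fun _ => 1)); [apply continuous_fst | apply continuous_const].
  - apply (continuous_opp (V := R_NormedModule)), continuous_snd.
Qed.

(* Polynomials in [x], [mu] and the partial derivatives of [I]; [dexpr_dx] and
   [dexpr_dy] are the formal partial derivatives. *)
Inductive dexpr :=
| DJ (i j : nat) | DX | DMu | DC (c : R) | DAdd (a b : dexpr) | DMul (a b : dexpr).

Fixpoint dexpr_eval (I : R * R -> R) (e : dexpr) (p : R * R) : R :=
  match e with
  | DJ i j => pderiv I i j p
  | DX => fst p
  | DMu => mu p
  | DC c => c
  | DAdd a b => dexpr_eval I a p + dexpr_eval I b p
  | DMul a b => dexpr_eval I a p * dexpr_eval I b p
  end.

Fixpoint dexpr_dx (e : dexpr) : dexpr :=
  match e with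
  | DJ i j => DJ (S i) j
  | DX => DC 1
  | DMu => DMul (DMul (DC 2) DX) DMu
  | DC _ => DC 0
  | DAdd a b => DAdd (dexpr_dx a) (dexpr_dx b)
  | DMul a b => DAdd (DMul (dexpr_dx a) b) (DMul a (dexpr_dx b))
  end.

Fixpoint dexpr_dy (e : dexpr) : dexpr :=
  match e with
  | DJ i j => DJ i (S j)
  | DX => DC 0
  | DMu => DMul (DC (-1)) DMu
  | DC _ => DC 0
  | DAdd a b => DAdd (dexpr_dy a) (dexpr_dy b)
  | DMul a b => DAdd (DMul (dexpr_dy a) b) (DMul a (dexpr_dy b))
  end.

Section DexprCalculus.
Variable I : R * R -> R.
Hypothesis HI : real_analytic2 I.

Lemma continuous_dexpr_eval e (p : R * R) : continuous (dexpr_eval I e) p.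
Proof.
  induction e; cbn [dexpr_eval].
  - now apply continuous_pderiv.
  - destruct p; apply continuous_fst.
  - apply continuous_mu.
  - apply continuous_const.
  - now apply continuous_Rplus2.
  - now apply continuous_Rmult2.
Qed.

Lemma is_derive_dexpr_x e p :
  is_derive (fun t => dexpr_eval I e (t, snd p)) (fst p) (dexpr_eval I (dexpr_dx e) p).
Proof.
  destruct p as [x y]. induction e; cbn [dexpr_eval dexpr_dx fst snd].
  - exact (is_derive_pderiv_x I HI i j (x, y)).
  - apply (is_derive_id (K := R_AbsRing)).
  - unfold mu; simpl. auto_derive; [constructor|]. unfold Rminus. ring.
  - apply is_derive_Rconst.
  - now apply is_derive_Rplus.
  - now apply is_derive_Rmult.
Qed.

Lemma is_derive_dexpr_y e p :
  is_derive (fun t => dexpr_eval I e (fst p, t)) (snd p) (dexpr_eval I (dexpr_dy e) p).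
Proof.
  destruct p as [x y]. induction e; cbn [dexpr_eval dexpr_dy fst snd].
  - exact (is_derive_pderiv_y I HI i j (x, y)).
  - apply is_derive_Rconst.
  - unfold mu; simpl. auto_derive; [constructor|]. unfold Rminus. ring.
  - apply is_derive_Rconst.
  - now apply is_derive_Rplus.
  - now apply is_derive_Rmult.
Qed.

End DexprCalculus.

Definition grad_expr := DMul DMu (DAdd (DMul (DJ 1 0) (DJ 1 0)) (DMul (DJ 0 1) (DJ 0 1))).

Definition lap_expr := DMul DMu (DAdd (DJ 2 0) (DJ 0 2)).

Lemma grad_norm2_conf I p :
  grad_norm2 conf_factor zero_fun conf_factor I p = dexpr_eval I grad_expr p.
Proof.
  unfold grad_norm2, metric_det, zero_fun. cbn.
  pose proof (conf_factor_mu p). pose proof (exp_pos (snd p - fst p ^ 2)).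
  fold (conf_factor p) in *.
  replace (mu p) with (/ conf_factor p) by (field_simplify_eq; lra).
  field. lra.
Qed.

Lemma partial_x_ext (F G : R * R -> R) p :
  (forall q, F q = G q) -> partial_x F p = partial_x G p.
Proof. intro H. apply Derive_ext. intro; apply H. Qed.

Lemma partial_y_ext (F G : R * R -> R) p :
  (forall q, F q = G q) -> partial_y F p = partial_y G p.
Proof. intro H. apply Derive_ext. intro; apply H. Qed.

Lemma laplace_beltrami_conf I p :
  laplace_beltrami conf_factor zero_fun conf_factor I p = dexpr_eval I lap_expr p.
Proof.
  unfold laplace_beltrami, metric_det, zero_fun.
  assert (Hc : forall q, 0 < conf_factor q) by (intro; apply exp_pos).
  assert (Hs : forall q, sqrt (conf_factor q * conf_factor q - 0 ^ 2) = conf_factor q).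
  { intro q. rewrite pow_i, Rminus_0_r by lia. apply sqrt_square. left; apply Hc. }
  assert (E1 : forall q, sqrt (conf_factor q * conf_factor q - 0 ^ 2) *
     ((conf_factor q * partial_x I q - 0 * partial_y I q) / (conf_factor q * conf_factor q - 0 ^ 2))
     = partial_x I q).
  { intro q. rewrite Hs. specialize (Hc q). field. lra. }
  assert (E2 : forall q, sqrt (conf_factor q * conf_factor q - 0 ^ 2) *
     ((- 0 * partial_x I q + conf_factor q * partial_y I q)
      / (conf_factor q * conf_factor q - 0 ^ 2))
     = partial_y I q).
  { intro q. rewrite Hs. specialize (Hc q). field. lra. }
  rewrite (partial_x_ext _ (partial_x I) p E1), (partial_y_ext _ (partial_y I) p E2).
  rewrite Hs. cbn.
  pose proof (conf_factor_mu p). specialize (Hc p).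
  replace (mu p) with (/ conf_factor p) by (field_simplify_eq; lra).
  reflexivity.
Qed.

(** * Level components and the Jacobian identity *)

Lemma continuous_pair (f g : R -> R) (s : R) :
  continuous f s -> continuous g s -> continuous (fun t => (f t, g t)) s.
Proof.
  intros Hf Hg. apply (continuous_comp_2 f g pair); auto.
  apply (continuous_ext (fun z : R * R => z)); [now intros [u v] | apply continuous_id].
Qed.

Lemma continuous_open_preimage (g : R -> R * R) (U : R * R -> Prop) (s : R) :
  open U -> U (g s) -> continuous g s ->
  exists d, 0 < d /\ forall s', Rabs (s' - s) < d -> U (g s').
Proof.
  intros HU Hs Hc. destruct (Hc U (HU _ Hs)) as [d Hd].
  exists d. split; [apply cond_pos|]. intros s' H. exact (Hd s' H).
Qed.

Section PathConnected.
Variables (g : R -> R * R) (a b : R).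
Hypothesis Hg : forall s, a <= s <= b -> continuous g s.
Let image := fun z => exists s, a <= s <= b /\ z = g s.

(* Take the supremum [m] of the initial segment [s1, m) mapped into [U]; [g m]
   can lie neither in [U] nor in [V] since both are open. *)

Lemma path_no_separation (U V : R * R -> Prop) s1 s2 :
  open U -> open V -> (forall z, image z -> U z \/ V z) ->
  (forall z, ~ (image z /\ U z /\ V z)) ->
  a <= s1 -> s1 < s2 -> s2 <= b -> U (g s1) -> V (g s2) -> False.
Proof.
  intros HU HV Hcov Hdis H1 H12 H2 HU1 HV2.
  assert (Him : forall s, a <= s <= b -> image (g s)) by (intros s Hs; now exists s).
  set (E := fun s => s1 <= s <= s2 /\ forall s', s1 <= s' <= s -> U (g s')).
  assert (HE1 : E s1) by (split; [lra | intros s' Hs'; now replace s' with s1 by lra]).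
  assert (HEb : bound E) by (exists s2; intros s [Hs _]; lra).
  destruct (completeness E HEb (ex_intro _ s1 HE1)) as [m [Hub Hlub]].
  assert (Hm1 : s1 <= m) by now apply Hub.
  assert (Hm2 : m <= s2) by (apply Hlub; intros s [Hs _]; lra).
  assert (Hbelow : forall s', s1 <= s' < m -> U (g s')).
  { intros s' Hs'.
    destruct (classic (exists s, E s /\ s' <= s)) as [[s [[_ Hs] Hss]] | Hn]; [apply Hs; lra|].
    exfalso. assert (m <= s'); [|lra].
    apply Hlub. intros s Hs. destruct (Rle_lt_dec s s'); auto.
    exfalso; apply Hn; exists s; split; auto; lra. }
  destruct (Hcov (g m) (Him m ltac:(lra))) as [Um | Vm].
  - destruct (Req_dec m s2) as [E2|E2].
    { subst m. apply (Hdis (g s2)). split; [apply Him; lra | now split]. }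
    destruct (continuous_open_preimage g U m HU Um (Hg m ltac:(lra))) as [d [Hd Hd']].
    set (t := Rmin (m + d / 2) s2).
    assert (Ht1 : m < t) by (unfold t; apply Rmin_glb_lt; lra).
    assert (Ht2 : t <= s2) by apply Rmin_r.
    assert (Ht3 : t <= m + d / 2) by apply Rmin_l.
    assert (E t).
    { split; [lra|]. intros s' Hs'.
      destruct (Rlt_le_dec s' m); [apply Hbelow; lra|].
      apply Hd'. rewrite Rabs_pos_eq; lra. }
    specialize (Hub t H). lra.
  - destruct (Req_dec m s1) as [E1|E1].
    { subst m. apply (Hdis (g s1)). split; [apply Him; lra | now split]. }
    destruct (continuous_open_preimage g V m HV Vm (Hg m ltac:(lra))) as [d [Hd Hd']].
    set (t := Rmax (m - d / 2) s1).
    assert (Ht1 : t < m) by (unfold t; apply Rmax_lub_lt; lra).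
    assert (Ht2 : s1 <= t) by apply Rmax_r.
    assert (Ht3 : m - d / 2 <= t) by apply Rmax_l.
    apply (Hdis (g t)). split; [apply Him; lra | split; [apply Hbelow; lra|]].
    apply Hd'. rewrite Rabs_left1; lra.
Qed.

Lemma connected2_path_image : connected2 image.
Proof.
  intros U V HU HV Hcov Hdis.
  destruct (classic (forall z, ~ (image z /\ U z))) as [H|H]; [now left|].
  right. intros z [Az Vz]. apply H. intros z' [Az' Uz'].
  destruct Az as [s2 [Hs2 E2]]. destruct Az' as [s1 [Hs1 E1]]. subst.
  destruct (Rtotal_order s1 s2) as [Hl|[He|Hgt]].
  - apply (path_no_separation U V s1 s2); auto; lra.
  - subst. apply (Hdis (g s2)). split; [now exists s2 | auto].
  - apply (path_no_separation V U s2 s1); auto; try lra.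
    + intros z Hz. destruct (Hcov z Hz); auto.
    + intros z [H1 [H2 H3]]. apply (Hdis z); auto.
Qed.

End PathConnected.

Lemma same_level_component_of_path (w : R * R -> R) (g : R -> R * R) a b s0 s :
  (forall s, a <= s <= b -> continuous g s) ->
  (forall s, a <= s <= b -> w (g s) = w (g s0)) ->
  a <= s0 <= b -> a <= s <= b -> same_level_component w (g s0) (g s).
Proof.
  intros Hc Hw Hs0 Hs.
  exists (fun z => exists s, a <= s <= b /\ z = g s).
  split; [now apply connected2_path_image|].
  split; [now exists s0|]. split; [now exists s|].
  intros z [s' [Hs' E]]. subst. now apply Hw.
Qed.

Lemma continuous_R_iff (f : R -> R) (s : R) :
  continuous f s <->
  forall eps, 0 < eps -> exists d, 0 < d /\ forall x, Rabs (x - s) < d -> Rabs (f x - f s) < eps.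
Proof.
  split.
  - intros H eps He.
    destruct (H (ball (f s) (mkposreal eps He)) (locally_ball _ _)) as [d Hd].
    exists d. split; [apply cond_pos | intros x Hx; exact (Hd x Hx)].
  - intros H P [eps HP]. destruct (H eps (cond_pos eps)) as [d [Hd Hx]].
    exists (mkposreal d Hd). intros x Hxs. apply HP. exact (Hx x Hxs).
Qed.

Lemma Rabs_sub_le_of_between c u v :
  Rmin u v <= c <= Rmax u v -> Rabs (c - u) <= Rabs (v - u).
Proof.
  intro Hc. unfold Rmin, Rmax in Hc.
  destruct (Rle_dec u v); apply Rabs_le; [rewrite Rabs_pos_eq | rewrite Rabs_left]; lra.
Qed.

Lemma Rabs_mult_sub_le A A0 B B0 e :
  Rabs (A - A0) < e -> Rabs (B - B0) < e -> e <= 1 ->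
  Rabs (A * B - A0 * B0) <= e * (Rabs A0 + Rabs B0 + 1).
Proof.
  intros H1 H2 H3.
  replace (A * B - A0 * B0) with ((A - A0) * B + A0 * (B - B0)) by ring.
  eapply Rle_trans; [apply Rabs_triang|]. rewrite !Rabs_mult.
  assert (Rabs B <= Rabs B0 + e).
  { replace B with ((B - B0) + B0) by ring. eapply Rle_trans; [apply Rabs_triang | lra]. }
  pose proof (Rabs_pos (A - A0)). pose proof (Rabs_pos A0).
  pose proof (Rabs_pos B). pose proof (Rabs_pos (B - B0)).
  assert (Rabs (A - A0) * Rabs B <= e * (Rabs B0 + 1)).
  { apply Rle_trans with (e * (Rabs B0 + e)); [apply Rmult_le_compat; lra | nra]. }
  assert (Rabs A0 * Rabs (B - B0) <= Rabs A0 * e) by (apply Rmult_le_compat_l; lra).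
  nra.
Qed.


Lemma jacobian_zero_of_approx (hx wy hy wx : R * R -> R) (p : R * R) :
  continuous hx p -> continuous wy p -> continuous hy p -> continuous wx p ->
  (forall a, 0 < a -> exists q1 q2 q3 q4,
     in_box p a q1 /\ in_box p a q2 /\ in_box p a q3 /\ in_box p a q4 /\
     hx q1 * wy q2 - hy q3 * wx q4 = 0) ->
  hx p * wy p - hy p * wx p = 0.
Proof.
  intros C1 C2 C3 C4 Happrox.
  set (T := hx p * wy p - hy p * wx p).
  destruct (Req_dec T 0) as [HT|HT]; [exact HT|]. exfalso.
  set (K := (Rabs (hx p) + Rabs (wy p) + 1) + (Rabs (hy p) + Rabs (wx p) + 1)).
  assert (HK : 0 < K).
  { unfold K. pose proof (Rabs_pos (hx p)). pose proof (Rabs_pos (wy p)).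
    pose proof (Rabs_pos (hy p)). pose proof (Rabs_pos (wx p)). lra. }
  assert (HTp : 0 < Rabs T) by now apply Rabs_pos_lt.
  set (e := Rmin 1 (Rabs T / (2 * K))).
  assert (He : 0 < e) by (apply Rmin_pos; [lra | apply Rdiv_lt_0_compat; lra]).
  assert (He1 : e <= 1) by apply Rmin_l.
  assert (He2 : e <= Rabs T / (2 * K)) by apply Rmin_r.
  destruct (proj1 (continuous_box_iff _ _) C1 e He) as [a1 [Ha1 B1]].
  destruct (proj1 (continuous_box_iff _ _) C2 e He) as [a2 [Ha2 B2]].
  destruct (proj1 (continuous_box_iff _ _) C3 e He) as [a3 [Ha3 B3]].
  destruct (proj1 (continuous_box_iff _ _) C4 e He) as [a4 [Ha4 B4]].
  set (a := Rmin (Rmin a1 a2) (Rmin a3 a4)).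
  assert (Ha : 0 < a) by (repeat apply Rmin_pos; auto).
  assert (a <= a1 /\ a <= a2 /\ a <= a3 /\ a <= a4) as (Ha1' & Ha2' & Ha3' & Ha4').
  { unfold a. pose proof (Rmin_l (Rmin a1 a2) (Rmin a3 a4)).
    pose proof (Rmin_r (Rmin a1 a2) (Rmin a3 a4)). pose proof (Rmin_l a1 a2).
    pose proof (Rmin_r a1 a2). pose proof (Rmin_l a3 a4). pose proof (Rmin_r a3 a4). lra. }
  destruct (Happrox a Ha) as (q1 & q2 & q3 & q4 & [Q1 Q1'] & [Q2 Q2'] & [Q3 Q3'] & [Q4 Q4'] & E).
  pose proof (Rabs_mult_sub_le _ _ _ _ e
    (B1 q1 ltac:(lra) ltac:(lra)) (B2 q2 ltac:(lra) ltac:(lra)) He1).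
  pose proof (Rabs_mult_sub_le _ _ _ _ e
    (B3 q3 ltac:(lra) ltac:(lra)) (B4 q4 ltac:(lra) ltac:(lra)) He1).
  assert (Rabs T <= e * K).
  { replace T with (- (hx q1 * wy q2 - hx p * wy p) + (hy q3 * wx q4 - hy p * wx p))
      by (unfold T; lra).
    eapply Rle_trans; [apply Rabs_triang|]. rewrite Rabs_Ropp. unfold K. lra. }
  assert (e * K <= Rabs T / 2).
  { apply Rle_trans with (Rabs T / (2 * K) * K); [apply Rmult_le_compat_r; lra|].
    right; field; lra. }
  lra.
Qed.

Section LevelCurve.
Variables (w wy : R * R -> R) (x0 y0 r : R).
Hypothesis Hwy : forall q, is_derive (fun t => w (fst q, t)) (snd q) (wy q).
Hypothesis Cw : forall q, continuous w q.
Hypothesis Hr : 0 < r.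
Hypothesis Hbox : forall x y, Rabs (x - x0) <= r -> Rabs (y - y0) <= r -> 0 < wy (x, y).

Lemma level_strict_incr_y x t1 t2 :
  Rabs (x - x0) <= r -> y0 - r <= t1 -> t1 < t2 -> t2 <= y0 + r -> w (x, t1) < w (x, t2).
Proof.
  intros Hx H1 H2 H3.
  destruct (MVT_is_derive (fun t => w (x, t)) (fun t => wy (x, t)) t1 t2) as [c [Hc E]].
  { intros t _. apply (Hwy (x, t)). }
  rewrite Rmin_left, Rmax_right in Hc by lra.
  assert (0 < wy (x, c)) by (apply Hbox; auto; apply Rabs_le; lra).
  assert (0 < wy (x, c) * (t2 - t1)) by (apply Rmult_lt_0_compat; lra).
  lra.
Qed.

Lemma level_curve_exists : exists d, 0 < d /\ d <= r /\ forall x, exists y,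
  Rabs (x - x0) < d -> y0 - r < y < y0 + r /\ w (x, y) = w (x0, y0).
Proof.
  set (c := w (x0, y0)).
  assert (Hx0 : Rabs (x0 - x0) <= r) by (rewrite Rminus_diag, Rabs_R0; lra).
  assert (Hlo : w (x0, y0 - r) < c) by (apply level_strict_incr_y; auto; lra).
  assert (Hhi : c < w (x0, y0 + r)) by (apply level_strict_incr_y; auto; lra).
  destruct (proj1 (continuous_box_iff _ _) (Cw (x0, y0 - r)) (c - w (x0, y0 - r)) ltac:(lra))
    as [e1 [He1 Hc1]].
  destruct (proj1 (continuous_box_iff _ _) (Cw (x0, y0 + r)) (w (x0, y0 + r) - c) ltac:(lra))
    as [e2 [He2 Hc2]].
  exists (Rmin r (Rmin e1 e2)). split; [repeat apply Rmin_pos; auto|]. split; [apply Rmin_l|].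
  pose proof (Rmin_l r (Rmin e1 e2)). pose proof (Rmin_r r (Rmin e1 e2)).
  pose proof (Rmin_l e1 e2). pose proof (Rmin_r e1 e2).
  intro x. destruct (Rlt_dec (Rabs (x - x0)) (Rmin r (Rmin e1 e2))) as [Hx|Hx];
    [|exists y0; intro; contradiction].
  assert (Ha : w (x, y0 - r) < c).
  { specialize (Hc1 (x, y0 - r) ltac:(cbn; lra) ltac:(cbn; rewrite Rminus_diag, Rabs_R0; lra)).
    apply Rabs_lt_between' in Hc1. cbn in Hc1. lra. }
  assert (Hb : c < w (x, y0 + r)).
  { specialize (Hc2 (x, y0 + r) ltac:(cbn; lra) ltac:(cbn; rewrite Rminus_diag, Rabs_R0; lra)).
    apply Rabs_lt_between' in Hc2. cbn in Hc2. lra. }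
  assert (Hcont : continuity (fun t => w (x, t) - c)).
  { intro t. apply (continuity_pt_of_is_derive _ t (wy (x, t) + 0)).
    apply is_derive_Rplus; [apply (Hwy (x, t)) | apply is_derive_Rconst]. }
  destruct (IVT (fun t => w (x, t) - c) (y0 - r) (y0 + r) Hcont ltac:(lra)
              ltac:(cbn; lra) ltac:(cbn; lra)) as [y [Hy1 Hy2]].
  exists y. intros _. cbn in Hy2. split; [|lra].
  split; [destruct (Req_dec y (y0 - r)); [subst; lra | lra]
         | destruct (Req_dec y (y0 + r)); [subst; lra | lra]].
Qed.

Section Curve.
Variables (d : R) (Y : R -> R).
Hypothesis Hdr : d <= r.
Hypothesis HY : forall x, Rabs (x - x0) < d -> y0 - r < Y x < y0 + r /\ w (x, Y x) = w (x0, y0).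

Lemma level_curve_unique x y :
  Rabs (x - x0) < d -> y0 - r <= y <= y0 + r -> w (x, y) = w (x0, y0) -> y = Y x.
Proof.
  intros Hx Hy E. destruct (HY x Hx) as [HY1 HY2].
  destruct (Rtotal_order y (Y x)) as [L|[L|L]]; auto.
  - assert (w (x, y) < w (x, Y x)) by (apply level_strict_incr_y; lra). lra.
  - assert (w (x, Y x) < w (x, y)) by (apply level_strict_incr_y; lra). lra.
Qed.

(* [w (x, _)] is increasing, so [Y x] is trapped between [Y s - e] and [Y s + e] as soon as
   [w (x, Y s - e) < w (x0, y0) < w (x, Y s + e)], which holds for [x] near [s]. *)

Lemma level_curve_continuous s : Rabs (s - x0) < d -> continuous Y s.
Proof.
  intro Hs. apply continuous_R_iff. intros eps He.
  destruct (HY s Hs) as [[Hs1 Hs2] Hs3].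
  set (e' := Rmin eps (Rmin (Y s - (y0 - r)) (y0 + r - Y s)) / 2).
  pose proof (Rmin_l eps (Rmin (Y s - (y0 - r)) (y0 + r - Y s))).
  pose proof (Rmin_r eps (Rmin (Y s - (y0 - r)) (y0 + r - Y s))).
  pose proof (Rmin_l (Y s - (y0 - r)) (y0 + r - Y s)).
  pose proof (Rmin_r (Y s - (y0 - r)) (y0 + r - Y s)).
  assert (He' : 0 < e') by (unfold e'; apply Rdiv_lt_0_compat; [repeat apply Rmin_pos | ]; lra).
  assert (e' < eps /\ e' < Y s - (y0 - r) /\ e' < y0 + r - Y s) as (He1 & He2 & He3)
    by (unfold e'; lra).
  assert (L1 : w (s, Y s - e') < w (x0, y0)) by (rewrite <- Hs3; apply level_strict_incr_y; lra).
  assert (L2 : w (x0, y0) < w (s, Y s + e')) by (rewrite <- Hs3; apply level_strict_incr_y; lra).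
  destruct (proj1 (continuous_box_iff _ _) (Cw (s, Y s - e'))
              (w (x0, y0) - w (s, Y s - e')) ltac:(lra))
    as [n1 [Hn1 Hcn1]].
  destruct (proj1 (continuous_box_iff _ _) (Cw (s, Y s + e'))
              (w (s, Y s + e') - w (x0, y0)) ltac:(lra))
    as [n2 [Hn2 Hcn2]].
  exists (Rmin (Rmin n1 n2) (d - Rabs (s - x0))). split; [repeat apply Rmin_pos; lra|].
  intros x Hx.
  pose proof (Rmin_l (Rmin n1 n2) (d - Rabs (s - x0))).
  pose proof (Rmin_r (Rmin n1 n2) (d - Rabs (s - x0))).
  pose proof (Rmin_l n1 n2). pose proof (Rmin_r n1 n2).
  assert (Hx0 : Rabs (x - x0) < d).
  { replace (x - x0) with ((x - s) + (s - x0)) by ring.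
    eapply Rle_lt_trans; [apply Rabs_triang | lra]. }
  specialize (Hcn1 (x, Y s - e') ltac:(cbn; lra) ltac:(cbn; rewrite Rminus_diag, Rabs_R0; lra)).
  specialize (Hcn2 (x, Y s + e') ltac:(cbn; lra) ltac:(cbn; rewrite Rminus_diag, Rabs_R0; lra)).
  apply Rabs_lt_between' in Hcn1. apply Rabs_lt_between' in Hcn2. cbn in Hcn1, Hcn2.
  destruct (HY x Hx0) as [[Hx1 Hx2] Hx3].
  assert (Hxr : Rabs (x - x0) <= r) by lra.
  apply Rabs_lt_between'. split.
  - destruct (Rlt_le_dec (Y s - eps) (Y x)); auto.
    assert (w (x, Y x) < w (x, Y s - e')) by (apply level_strict_incr_y; lra). lra.
  - destruct (Rlt_le_dec (Y x) (Y s + eps)); auto.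
    assert (w (x, Y s + e') < w (x, Y x)) by (apply level_strict_incr_y; lra). lra.
Qed.

End Curve.

Lemma level_curve : exists d Y, 0 < d /\ Y x0 = y0 /\
  forall x, Rabs (x - x0) < d -> w (x, Y x) = w (x0, y0) /\ continuous Y x.
Proof.
  destruct level_curve_exists as [d [Hd [Hdr Hex]]].
  set (Y := fun x => proj1_sig (constructive_indefinite_description _ (Hex x))).
  assert (HY : forall x, Rabs (x - x0) < d -> y0 - r < Y x < y0 + r /\ w (x, Y x) = w (x0, y0)).
  { intros x Hx. unfold Y. destruct (constructive_indefinite_description _ (Hex x)) as [y Hy].
    exact (Hy Hx). }
  exists d, Y. split; [exact Hd | split].
  - symmetry. apply (level_curve_unique d Y); auto; [rewrite Rminus_diag, Rabs_R0 |]; lra.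
  - intros x Hx. split; [apply HY, Hx | now apply (level_curve_continuous d Y)].
Qed.

End LevelCurve.

(* Along the level curve [x |-> (x, Y x)] of [w] through [(x0, y0)] both [w] and [h] are
   constant; the mean value theorem turns this into an approximate vanishing of the
   Jacobian [hx wy - hy wx] at nearby points. *)
Section LevelJacobian.
Variables (w wx wy h hx hy : R * R -> R) (x0 y0 : R).
Hypothesis Hwx : forall q, is_derive (fun t => w (t, snd q)) (fst q) (wx q).
Hypothesis Hwy : forall q, is_derive (fun t => w (fst q, t)) (snd q) (wy q).
Hypothesis Hhx : forall q, is_derive (fun t => h (t, snd q)) (fst q) (hx q).
Hypothesis Hhy : forall q, is_derive (fun t => h (fst q, t)) (snd q) (hy q).
Hypothesis Cw : forall q, continuous w q.
Hypothesis Cwx : forall q, continuous wx q.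
Hypothesis Cwy : forall q, continuous wy q.
Hypothesis Chx : forall q, continuous hx q.
Hypothesis Chy : forall q, continuous hy q.
Hypothesis Hlev : forall q, same_level_component w (x0, y0) q -> h q = h (x0, y0).

Lemma level_curve_in_component : 0 < wy (x0, y0) -> exists d Y, 0 < d /\ Y x0 = y0 /\
  forall x, Rabs (x - x0) < d ->
    w (x, Y x) = w (x0, y0) /\ h (x, Y x) = h (x0, y0) /\ continuous Y x.
Proof.
  intro Hpos.
  destruct (proj1 (continuous_box_iff _ _) (Cwy (x0, y0)) (wy (x0, y0) / 2) ltac:(lra))
    as [d0 [Hd0 Hwy0]].
  assert (Hbox : forall x y, Rabs (x - x0) <= d0 / 2 -> Rabs (y - y0) <= d0 / 2 -> 0 < wy (x, y)).
  { intros x y H1 H2. specialize (Hwy0 (x, y) ltac:(cbn; lra) ltac:(cbn; lra)).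
    apply Rabs_lt_between' in Hwy0. lra. }
  destruct (level_curve w wy x0 y0 (d0 / 2) Hwy Cw ltac:(lra) Hbox) as [d [Y [Hd [HY0 HY]]]].
  set (g := fun s => (s, Y s)).
  assert (Hg0 : g x0 = (x0, y0)) by (unfold g; now rewrite HY0).
  exists (d / 2), Y. split; [lra | split; [exact HY0|]].
  intros x Hx. apply Rabs_lt_between' in Hx.
  split; [apply HY, Rabs_lt_between'; lra | split; [|apply HY, Rabs_lt_between'; lra]].
  apply Hlev. rewrite <- Hg0.
  apply (same_level_component_of_path w g (x0 - d / 2) (x0 + d / 2) x0 x); [| |lra|lra].
  - intros s Hs. apply continuous_pair; [apply continuous_id|].
    apply HY. apply Rabs_lt_between'; lra.
  - intros s Hs. rewrite Hg0. apply HY. apply Rabs_lt_between'; lra.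
Qed.

Lemma level_jacobian_of_pos :
  0 < wy (x0, y0) -> hx (x0, y0) * wy (x0, y0) - hy (x0, y0) * wx (x0, y0) = 0.
Proof.
  intro Hpos. destruct (level_curve_in_component Hpos) as [d [Y [Hd [HY0 HY]]]].
  apply jacobian_zero_of_approx; auto.
  intros a Ha.
  destruct (proj1 (continuous_R_iff _ _)
              (proj2 (proj2 (HY x0 ltac:(rewrite Rminus_diag, Rabs_R0; lra)))) a Ha)
    as [eta [Heta HYc]].
  set (x := x0 + Rmin (Rmin eta a) d / 2).
  pose proof (Rmin_l (Rmin eta a) d). pose proof (Rmin_r (Rmin eta a) d).
  pose proof (Rmin_l eta a). pose proof (Rmin_r eta a).
  assert (Hm : 0 < Rmin (Rmin eta a) d) by (repeat apply Rmin_pos; lra).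
  assert (Hxx : 0 < x - x0 < a) by (unfold x; lra).
  assert (Hxd : Rabs (x - x0) < d) by (rewrite Rabs_pos_eq; unfold x; lra).
  assert (HYx : Rabs (Y x - y0) < a).
  { rewrite <- HY0. apply HYc. rewrite Rabs_pos_eq; unfold x; lra. }
  destruct (MVT_is_derive (fun t => w (t, Y x)) (fun t => wx (t, Y x)) x0 x) as [c1 [Hq1 E1]].
  { intros t _. apply (Hwx (t, Y x)). }
  destruct (MVT_is_derive (fun t => w (x0, t)) (fun t => wy (x0, t)) y0 (Y x)) as [c2 [Hq2 E2]].
  { intros t _. apply (Hwy (x0, t)). }
  destruct (MVT_is_derive (fun t => h (t, Y x)) (fun t => hx (t, Y x)) x0 x) as [c3 [Hq3 E3]].
  { intros t _. apply (Hhx (t, Y x)). }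
  destruct (MVT_is_derive (fun t => h (x0, t)) (fun t => hy (x0, t)) y0 (Y x)) as [c4 [Hq4 E4]].
  { intros t _. apply (Hhy (x0, t)). }
  apply Rabs_sub_le_of_between in Hq1, Hq2, Hq3, Hq4.
  rewrite (Rabs_pos_eq (x - x0)) in Hq1, Hq3 by lra.
  assert (Hz : Rabs (x0 - x0) < a) by (rewrite Rminus_diag, Rabs_R0; lra).
  exists (c3, Y x), (x0, c2), (x0, c4), (c1, Y x).
  repeat split; cbn; try lra.
  destruct (HY x Hxd) as [Hwc [Hhc _]].
  assert (Ew : wx (c1, Y x) * (x - x0) + wy (x0, c2) * (Y x - y0) = 0)
    by (rewrite <- E1, <- E2, Hwc; ring).
  assert (Eh : hx (c3, Y x) * (x - x0) + hy (x0, c4) * (Y x - y0) = 0)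
    by (rewrite <- E3, <- E4, Hhc; ring).
  apply (Rmult_eq_reg_l (x - x0)); [|lra].
  replace ((x - x0) * (hx (c3, Y x) * wy (x0, c2) - hy (x0, c4) * wx (c1, Y x)))
    with (wy (x0, c2) * (hx (c3, Y x) * (x - x0) + hy (x0, c4) * (Y x - y0))
          - hy (x0, c4) * (wx (c1, Y x) * (x - x0) + wy (x0, c2) * (Y x - y0))) by ring.
  rewrite Ew, Eh. ring.
Qed.

End LevelJacobian.

Lemma level_jacobian (w wx wy h hx hy : R * R -> R) x0 y0 :
  (forall q, is_derive (fun t => w (t, snd q)) (fst q) (wx q)) ->
  (forall q, is_derive (fun t => w (fst q, t)) (snd q) (wy q)) ->
  (forall q, is_derive (fun t => h (t, snd q)) (fst q) (hx q)) ->
  (forall q, is_derive (fun t => h (fst q, t)) (snd q) (hy q)) ->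
  (forall q, continuous w q) -> (forall q, continuous wx q) -> (forall q, continuous wy q) ->
  (forall q, continuous hx q) -> (forall q, continuous hy q) ->
  (forall q, same_level_component w (x0, y0) q -> h q = h (x0, y0)) ->
  wy (x0, y0) <> 0 -> hx (x0, y0) * wy (x0, y0) - hy (x0, y0) * wx (x0, y0) = 0.
Proof.
  intros H1 H2 H3 H4 C1 C2 C3 C4 C5 HL Hne.
  destruct (Rlt_or_le 0 (wy (x0, y0))) as [Hp|Hn].
  { now apply (level_jacobian_of_pos w wx wy h hx hy). }
  assert (Hopp : forall (f : R -> R) x l, is_derive f x l -> is_derive (fun t => - f t) x (- l))
    by (intros; now apply (is_derive_opp (K := R_AbsRing) (V := R_NormedModule))).
  assert (Copp : forall F (q : R * R), continuous F q -> continuous (fun q => - F q) q)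
    by (intros; now apply (continuous_opp (V := R_NormedModule))).
  assert (HL' : forall q, same_level_component (fun q => - w q) (x0, y0) q -> h q = h (x0, y0)).
  { intros q [A [HA [HA1 [HA2 HA3]]]]. apply HL. exists A. repeat split; auto.
    intros z Hz. specialize (HA3 z Hz). lra. }
  pose proof (level_jacobian_of_pos (fun q => - w q) (fun q => - wx q) (fun q => - wy q) h hx hy
    x0 y0 (fun q => Hopp _ _ _ (H1 q)) (fun q => Hopp _ _ _ (H2 q)) H3 H4
    (fun q => Copp _ _ (C1 q)) (fun q => Copp _ _ (C2 q)) (fun q => Copp _ _ (C3 q)) C4 C5 HL')
    as E.
  cbn in E. assert (0 < - wy (x0, y0)) by (destruct Hn; [lra | contradiction]).
  specialize (E H). lra.
Qed.

(** * The elimination certificate *)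

(* The polynomials below are stated at a fixed point [q], with [u i j] for
   [d_x^i d_y^j I], [m] for [mu] and [x] for the abscissa. [jac_f*] and [jac_g*] are the
   Jacobians [I_y d_x - I_x d_y] of [f = mu |grad I|^2] and [g = mu (I_xx + I_yy)] and
   their partial derivatives; each [elim] polynomial is a combination of earlier ones,
   ending with the factored [elim11]. *)
Section Certificate.
Variables (I : R * R -> R) (q : R * R).
Local Notation u i j := (pderiv I i j q).
Local Notation x := (fst q).
Local Notation m := (mu q).

Definition jac_f :=
  (-2)*m*(u 1 0)^2*(u 1 1) + m*(u 1 0)^3 + 2*m*(u 0 1)*(u 1 0)*(u 2 0)
    + (-2)*m*(u 0 1)*(u 1 0)*(u 0 2) + 2*m*(u 0 1)^2*(u 1 1) + m*(u 0 1)^2*(u 1 0)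
    + 2*x*m*(u 0 1)*(u 1 0)^2 + 2*x*m*(u 0 1)^3.

Definition jac_f_x :=
  (-2)*m*(u 1 0)*(u 1 1)*(u 2 0) + (-2)*m*(u 1 0)*(u 0 2)*(u 1 1) + (-2)*m*(u 1 0)^2*(u 2 1)
    + 3*m*(u 1 0)^2*(u 2 0) + 2*m*(u 0 1)*(u 2 0)^2 + 4*m*(u 0 1)*(u 1 1)^2
    + (-2)*m*(u 0 1)*(u 0 2)*(u 2 0) + 2*m*(u 0 1)*(u 1 0)*(u 3 0)
    + (-2)*m*(u 0 1)*(u 1 0)*(u 1 2) + 2*m*(u 0 1)*(u 1 0)*(u 1 1) + 2*m*(u 0 1)*(u 1 0)^2
    + 2*m*(u 0 1)^2*(u 2 1) + m*(u 0 1)^2*(u 2 0) + 2*m*(u 0 1)^3 + (-2)*x*m*(u 1 0)^2*(u 1 1)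
    + 2*x*m*(u 1 0)^3 + 8*x*m*(u 0 1)*(u 1 0)*(u 2 0) + (-4)*x*m*(u 0 1)*(u 1 0)*(u 0 2)
    + 10*x*m*(u 0 1)^2*(u 1 1) + 2*x*m*(u 0 1)^2*(u 1 0) + 4*x^2*m*(u 0 1)*(u 1 0)^2
    + 4*x^2*m*(u 0 1)^3.

Definition jac_f_y :=
  (-4)*m*(u 1 0)*(u 1 1)^2 + 2*m*(u 1 0)*(u 0 2)*(u 2 0) + (-2)*m*(u 1 0)*(u 0 2)^2
    + (-2)*m*(u 1 0)^2*(u 1 2) + 5*m*(u 1 0)^2*(u 1 1) + (-1)*m*(u 1 0)^3
    + 2*m*(u 0 1)*(u 1 1)*(u 2 0) + 2*m*(u 0 1)*(u 0 2)*(u 1 1) + 2*m*(u 0 1)*(u 1 0)*(u 2 1)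
    + (-2)*m*(u 0 1)*(u 1 0)*(u 0 3) + (-2)*m*(u 0 1)*(u 1 0)*(u 2 0)
    + 4*m*(u 0 1)*(u 1 0)*(u 0 2) + 2*m*(u 0 1)^2*(u 1 2) + (-1)*m*(u 0 1)^2*(u 1 1)
    + (-1)*m*(u 0 1)^2*(u 1 0) + 2*x*m*(u 1 0)^2*(u 0 2) + 4*x*m*(u 0 1)*(u 1 0)*(u 1 1)
    + (-2)*x*m*(u 0 1)*(u 1 0)^2 + 6*x*m*(u 0 1)^2*(u 0 2) + (-2)*x*m*(u 0 1)^3.

Definition jac_f_xx :=
  4*m*(u 1 1)^3 + (-4)*m*(u 0 2)*(u 1 1)*(u 2 0) + (-6)*m*(u 1 0)*(u 2 0)*(u 2 1)
    + 6*m*(u 1 0)*(u 2 0)^2 + (-4)*m*(u 1 0)*(u 1 1)*(u 1 2) + 2*m*(u 1 0)*(u 1 1)^2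
    + (-2)*m*(u 1 0)*(u 0 2)*(u 2 1) + (-2)*m*(u 1 0)^2*(u 3 1) + 3*m*(u 1 0)^2*(u 3 0)
    + 2*m*(u 1 0)^3 + 6*m*(u 0 1)*(u 2 0)*(u 3 0) + (-4)*m*(u 0 1)*(u 2 0)*(u 1 2)
    + 12*m*(u 0 1)*(u 1 1)*(u 2 1) + 4*m*(u 0 1)*(u 1 1)*(u 2 0)
    + (-2)*m*(u 0 1)*(u 0 2)*(u 3 0) + 2*m*(u 0 1)*(u 1 0)*(u 4 0)
    + (-2)*m*(u 0 1)*(u 1 0)*(u 2 2) + 2*m*(u 0 1)*(u 1 0)*(u 2 1)
    + 12*m*(u 0 1)*(u 1 0)*(u 2 0) + (-4)*m*(u 0 1)*(u 1 0)*(u 0 2) + 2*m*(u 0 1)^2*(u 3 1)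
    + m*(u 0 1)^2*(u 3 0) + 16*m*(u 0 1)^2*(u 1 1) + 2*m*(u 0 1)^2*(u 1 0)
    + (-8)*x*m*(u 1 0)*(u 0 2)*(u 1 1) + (-6)*x*m*(u 1 0)^2*(u 2 1) + 12*x*m*(u 1 0)^2*(u 2 0)
    + 12*x*m*(u 0 1)*(u 2 0)^2 + 28*x*m*(u 0 1)*(u 1 1)^2 + (-8)*x*m*(u 0 1)*(u 0 2)*(u 2 0)
    + 12*x*m*(u 0 1)*(u 1 0)*(u 3 0) + (-8)*x*m*(u 0 1)*(u 1 0)*(u 1 2)
    + 8*x*m*(u 0 1)*(u 1 0)*(u 1 1) + 12*x*m*(u 0 1)*(u 1 0)^2 + 14*x*m*(u 0 1)^2*(u 2 1)
    + 4*x*m*(u 0 1)^2*(u 2 0) + 12*x*m*(u 0 1)^3 + 4*x^2*m*(u 1 0)^3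
    + 24*x^2*m*(u 0 1)*(u 1 0)*(u 2 0) + (-8)*x^2*m*(u 0 1)*(u 1 0)*(u 0 2)
    + 32*x^2*m*(u 0 1)^2*(u 1 1) + 4*x^2*m*(u 0 1)^2*(u 1 0) + 8*x^3*m*(u 0 1)*(u 1 0)^2
    + 8*x^3*m*(u 0 1)^3.

Definition jac_f_yy :=
  (-4)*m*(u 1 1)^3 + 4*m*(u 0 2)*(u 1 1)*(u 2 0) + 2*m*(u 1 0)*(u 2 0)*(u 0 3)
    + (-12)*m*(u 1 0)*(u 1 1)*(u 1 2) + 14*m*(u 1 0)*(u 1 1)^2 + 4*m*(u 1 0)*(u 0 2)*(u 2 1)
    + (-6)*m*(u 1 0)*(u 0 2)*(u 0 3) + (-4)*m*(u 1 0)*(u 0 2)*(u 2 0) + 6*m*(u 1 0)*(u 0 2)^2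
    + (-2)*m*(u 1 0)^2*(u 1 3) + 7*m*(u 1 0)^2*(u 1 2) + (-8)*m*(u 1 0)^2*(u 1 1) + m*(u 1 0)^3
    + 2*m*(u 0 1)*(u 2 0)*(u 1 2) + 4*m*(u 0 1)*(u 1 1)*(u 2 1) + (-4)*m*(u 0 1)*(u 1 1)*(u 2 0)
    + 6*m*(u 0 1)*(u 0 2)*(u 1 2) + 2*m*(u 0 1)*(u 1 0)*(u 2 2) + (-2)*m*(u 0 1)*(u 1 0)*(u 0 4)
    + (-4)*m*(u 0 1)*(u 1 0)*(u 2 1) + 6*m*(u 0 1)*(u 1 0)*(u 0 3) + 2*m*(u 0 1)*(u 1 0)*(u 2 0)
    + (-6)*m*(u 0 1)*(u 1 0)*(u 0 2) + 2*m*(u 0 1)^2*(u 1 3) + (-3)*m*(u 0 1)^2*(u 1 2)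
    + m*(u 0 1)^2*(u 1 0) + 8*x*m*(u 1 0)*(u 0 2)*(u 1 1) + 2*x*m*(u 1 0)^2*(u 0 3)
    + (-4)*x*m*(u 1 0)^2*(u 0 2) + 4*x*m*(u 0 1)*(u 1 1)^2 + 12*x*m*(u 0 1)*(u 0 2)^2
    + 4*x*m*(u 0 1)*(u 1 0)*(u 1 2) + (-8)*x*m*(u 0 1)*(u 1 0)*(u 1 1) + 2*x*m*(u 0 1)*(u 1 0)^2
    + 6*x*m*(u 0 1)^2*(u 0 3) + (-12)*x*m*(u 0 1)^2*(u 0 2) + 2*x*m*(u 0 1)^3.

Definition jac_g :=
  (-1)*m*(u 1 0)*(u 2 1) + (-1)*m*(u 1 0)*(u 0 3) + m*(u 1 0)*(u 2 0) + m*(u 1 0)*(u 0 2)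
    + m*(u 0 1)*(u 3 0) + m*(u 0 1)*(u 1 2) + 2*x*m*(u 0 1)*(u 2 0) + 2*x*m*(u 0 1)*(u 0 2).

Definition jac_g_x :=
  (-1)*m*(u 2 0)*(u 2 1) + (-1)*m*(u 2 0)*(u 0 3) + m*(u 2 0)^2 + m*(u 1 1)*(u 3 0)
    + m*(u 1 1)*(u 1 2) + m*(u 0 2)*(u 2 0) + (-1)*m*(u 1 0)*(u 3 1) + (-1)*m*(u 1 0)*(u 1 3)
    + m*(u 1 0)*(u 3 0) + m*(u 1 0)*(u 1 2) + m*(u 0 1)*(u 4 0) + m*(u 0 1)*(u 2 2)
    + 2*m*(u 0 1)*(u 2 0) + 2*m*(u 0 1)*(u 0 2) + 2*x*m*(u 1 1)*(u 2 0) + 2*x*m*(u 0 2)*(u 1 1)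
    + (-2)*x*m*(u 1 0)*(u 2 1) + (-2)*x*m*(u 1 0)*(u 0 3) + 2*x*m*(u 1 0)*(u 2 0)
    + 2*x*m*(u 1 0)*(u 0 2) + 4*x*m*(u 0 1)*(u 3 0) + 4*x*m*(u 0 1)*(u 1 2)
    + 4*x^2*m*(u 0 1)*(u 2 0) + 4*x^2*m*(u 0 1)*(u 0 2).

Definition jac_g_y :=
  (-1)*m*(u 1 1)*(u 2 1) + (-1)*m*(u 1 1)*(u 0 3) + m*(u 1 1)*(u 2 0) + m*(u 0 2)*(u 3 0)
    + m*(u 0 2)*(u 1 2) + m*(u 0 2)*(u 1 1) + (-1)*m*(u 1 0)*(u 2 2) + (-1)*m*(u 1 0)*(u 0 4)
    + 2*m*(u 1 0)*(u 2 1) + 2*m*(u 1 0)*(u 0 3) + (-1)*m*(u 1 0)*(u 2 0)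
    + (-1)*m*(u 1 0)*(u 0 2) + m*(u 0 1)*(u 3 1) + m*(u 0 1)*(u 1 3) + (-1)*m*(u 0 1)*(u 3 0)
    + (-1)*m*(u 0 1)*(u 1 2) + 2*x*m*(u 0 2)*(u 2 0) + 2*x*m*(u 0 2)^2 + 2*x*m*(u 0 1)*(u 2 1)
    + 2*x*m*(u 0 1)*(u 0 3) + (-2)*x*m*(u 0 1)*(u 2 0) + (-2)*x*m*(u 0 1)*(u 0 2).

Definition elim1 :=
  4*m^2*(u 0 1)*(u 1 1)^3 + (-4)*m^2*(u 0 1)*(u 0 2)*(u 1 1)*(u 2 0)
    + (-4)*m^2*(u 0 1)*(u 1 0)*(u 2 0)*(u 2 1) + 2*m^2*(u 0 1)*(u 1 0)*(u 2 0)*(u 0 3)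
    + 4*m^2*(u 0 1)*(u 1 0)*(u 2 0)^2 + (-2)*m^2*(u 0 1)*(u 1 0)*(u 1 1)*(u 3 0)
    + (-6)*m^2*(u 0 1)*(u 1 0)*(u 1 1)*(u 1 2) + 2*m^2*(u 0 1)*(u 1 0)*(u 1 1)^2
    + (-2)*m^2*(u 0 1)*(u 1 0)*(u 0 2)*(u 2 1) + (-2)*m^2*(u 0 1)*(u 1 0)*(u 0 2)*(u 2 0)
    + 2*m^2*(u 0 1)*(u 1 0)^2*(u 1 3) + m^2*(u 0 1)*(u 1 0)^2*(u 3 0)
    + (-2)*m^2*(u 0 1)*(u 1 0)^2*(u 1 2) + 2*m^2*(u 0 1)*(u 1 0)^3
    + 6*m^2*(u 0 1)^2*(u 2 0)*(u 3 0) + (-4)*m^2*(u 0 1)^2*(u 2 0)*(u 1 2)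
    + 12*m^2*(u 0 1)^2*(u 1 1)*(u 2 1) + 4*m^2*(u 0 1)^2*(u 1 1)*(u 2 0)
    + (-2)*m^2*(u 0 1)^2*(u 0 2)*(u 3 0) + (-4)*m^2*(u 0 1)^2*(u 1 0)*(u 2 2)
    + 2*m^2*(u 0 1)^2*(u 1 0)*(u 2 1) + 8*m^2*(u 0 1)^2*(u 1 0)*(u 2 0)
    + (-8)*m^2*(u 0 1)^2*(u 1 0)*(u 0 2) + 2*m^2*(u 0 1)^3*(u 3 1) + m^2*(u 0 1)^3*(u 3 0)
    + 16*m^2*(u 0 1)^3*(u 1 1) + 2*m^2*(u 0 1)^3*(u 1 0)
    + (-4)*x*m^2*(u 0 1)*(u 1 0)*(u 1 1)*(u 2 0) + (-12)*x*m^2*(u 0 1)*(u 1 0)*(u 0 2)*(u 1 1)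
    + (-2)*x*m^2*(u 0 1)*(u 1 0)^2*(u 2 1) + 4*x*m^2*(u 0 1)*(u 1 0)^2*(u 0 3)
    + 8*x*m^2*(u 0 1)*(u 1 0)^2*(u 2 0) + (-4)*x*m^2*(u 0 1)*(u 1 0)^2*(u 0 2)
    + 12*x*m^2*(u 0 1)^2*(u 2 0)^2 + 28*x*m^2*(u 0 1)^2*(u 1 1)^2
    + (-8)*x*m^2*(u 0 1)^2*(u 0 2)*(u 2 0) + 4*x*m^2*(u 0 1)^2*(u 1 0)*(u 3 0)
    + (-16)*x*m^2*(u 0 1)^2*(u 1 0)*(u 1 2) + 8*x*m^2*(u 0 1)^2*(u 1 0)*(u 1 1)
    + 12*x*m^2*(u 0 1)^2*(u 1 0)^2 + 14*x*m^2*(u 0 1)^3*(u 2 1) + 4*x*m^2*(u 0 1)^3*(u 2 0)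
    + 12*x*m^2*(u 0 1)^4 + 4*x^2*m^2*(u 0 1)*(u 1 0)^3 + 16*x^2*m^2*(u 0 1)^2*(u 1 0)*(u 2 0)
    + (-16)*x^2*m^2*(u 0 1)^2*(u 1 0)*(u 0 2) + 32*x^2*m^2*(u 0 1)^3*(u 1 1)
    + 4*x^2*m^2*(u 0 1)^3*(u 1 0) + 8*x^3*m^2*(u 0 1)^2*(u 1 0)^2 + 8*x^3*m^2*(u 0 1)^4.

Definition elim2 :=
  4*m^3*(u 0 1)^2*(u 1 1)^3 + (-4)*m^3*(u 0 1)^2*(u 0 2)*(u 1 1)*(u 2 0)
    + (-4)*m^3*(u 0 1)^2*(u 1 0)*(u 2 0)*(u 2 1) + 2*m^3*(u 0 1)^2*(u 1 0)*(u 2 0)*(u 0 3)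
    + 4*m^3*(u 0 1)^2*(u 1 0)*(u 2 0)^2 + (-2)*m^3*(u 0 1)^2*(u 1 0)*(u 1 1)*(u 3 0)
    + (-6)*m^3*(u 0 1)^2*(u 1 0)*(u 1 1)*(u 1 2) + 2*m^3*(u 0 1)^2*(u 1 0)*(u 1 1)^2
    + (-2)*m^3*(u 0 1)^2*(u 1 0)*(u 0 2)*(u 2 1) + (-2)*m^3*(u 0 1)^2*(u 1 0)*(u 0 2)*(u 2 0)
    + 2*m^3*(u 0 1)^2*(u 1 0)^2*(u 1 3) + m^3*(u 0 1)^2*(u 1 0)^2*(u 3 0)
    + (-2)*m^3*(u 0 1)^2*(u 1 0)^2*(u 1 2) + 2*m^3*(u 0 1)^2*(u 1 0)^3
    + 6*m^3*(u 0 1)^3*(u 2 0)*(u 3 0) + (-4)*m^3*(u 0 1)^3*(u 2 0)*(u 1 2)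
    + 14*m^3*(u 0 1)^3*(u 1 1)*(u 2 1) + 2*m^3*(u 0 1)^3*(u 1 1)*(u 0 3)
    + 2*m^3*(u 0 1)^3*(u 1 1)*(u 2 0) + (-4)*m^3*(u 0 1)^3*(u 0 2)*(u 3 0)
    + (-2)*m^3*(u 0 1)^3*(u 0 2)*(u 1 2) + (-2)*m^3*(u 0 1)^3*(u 0 2)*(u 1 1)
    + (-2)*m^3*(u 0 1)^3*(u 1 0)*(u 2 2) + 2*m^3*(u 0 1)^3*(u 1 0)*(u 0 4)
    + (-2)*m^3*(u 0 1)^3*(u 1 0)*(u 2 1) + (-4)*m^3*(u 0 1)^3*(u 1 0)*(u 0 3)
    + 10*m^3*(u 0 1)^3*(u 1 0)*(u 2 0) + (-6)*m^3*(u 0 1)^3*(u 1 0)*(u 0 2)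
    + (-2)*m^3*(u 0 1)^4*(u 1 3) + 3*m^3*(u 0 1)^4*(u 3 0) + 2*m^3*(u 0 1)^4*(u 1 2)
    + 16*m^3*(u 0 1)^4*(u 1 1) + 2*m^3*(u 0 1)^4*(u 1 0)
    + (-4)*x*m^3*(u 0 1)^2*(u 1 0)*(u 1 1)*(u 2 0)
    + (-12)*x*m^3*(u 0 1)^2*(u 1 0)*(u 0 2)*(u 1 1) + (-2)*x*m^3*(u 0 1)^2*(u 1 0)^2*(u 2 1)
    + 4*x*m^3*(u 0 1)^2*(u 1 0)^2*(u 0 3) + 8*x*m^3*(u 0 1)^2*(u 1 0)^2*(u 2 0)
    + (-4)*x*m^3*(u 0 1)^2*(u 1 0)^2*(u 0 2) + 12*x*m^3*(u 0 1)^3*(u 2 0)^2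
    + 28*x*m^3*(u 0 1)^3*(u 1 1)^2 + (-12)*x*m^3*(u 0 1)^3*(u 0 2)*(u 2 0)
    + (-4)*x*m^3*(u 0 1)^3*(u 0 2)^2 + 4*x*m^3*(u 0 1)^3*(u 1 0)*(u 3 0)
    + (-16)*x*m^3*(u 0 1)^3*(u 1 0)*(u 1 2) + 8*x*m^3*(u 0 1)^3*(u 1 0)*(u 1 1)
    + 12*x*m^3*(u 0 1)^3*(u 1 0)^2 + 10*x*m^3*(u 0 1)^4*(u 2 1) + (-4)*x*m^3*(u 0 1)^4*(u 0 3)
    + 8*x*m^3*(u 0 1)^4*(u 2 0) + 4*x*m^3*(u 0 1)^4*(u 0 2) + 12*x*m^3*(u 0 1)^5
    + 4*x^2*m^3*(u 0 1)^2*(u 1 0)^3 + 16*x^2*m^3*(u 0 1)^3*(u 1 0)*(u 2 0)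
    + (-16)*x^2*m^3*(u 0 1)^3*(u 1 0)*(u 0 2) + 32*x^2*m^3*(u 0 1)^4*(u 1 1)
    + 4*x^2*m^3*(u 0 1)^4*(u 1 0) + 8*x^3*m^3*(u 0 1)^3*(u 1 0)^2 + 8*x^3*m^3*(u 0 1)^5.

Definition elim3 :=
  (-8)*m^4*(u 0 1)^3*(u 1 0)^2*(u 2 0)*(u 2 1) + 8*m^4*(u 0 1)^3*(u 1 0)^2*(u 2 0)*(u 0 3)
    + 8*m^4*(u 0 1)^3*(u 1 0)^2*(u 2 0)^2 + (-4)*m^4*(u 0 1)^3*(u 1 0)^2*(u 1 1)*(u 3 0)
    + (-36)*m^4*(u 0 1)^3*(u 1 0)^2*(u 1 1)*(u 1 2) + 32*m^4*(u 0 1)^3*(u 1 0)^2*(u 1 1)^2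
    + 4*m^4*(u 0 1)^3*(u 1 0)^2*(u 0 2)*(u 2 1) + (-12)*m^4*(u 0 1)^3*(u 1 0)^2*(u 0 2)*(u 0 3)
    + (-12)*m^4*(u 0 1)^3*(u 1 0)^2*(u 0 2)*(u 2 0) + 12*m^4*(u 0 1)^3*(u 1 0)^2*(u 0 2)^2
    + 2*m^4*(u 0 1)^3*(u 1 0)^3*(u 3 0) + 10*m^4*(u 0 1)^3*(u 1 0)^3*(u 1 2)
    + (-16)*m^4*(u 0 1)^3*(u 1 0)^3*(u 1 1) + 6*m^4*(u 0 1)^3*(u 1 0)^4
    + 12*m^4*(u 0 1)^4*(u 1 0)*(u 2 0)*(u 3 0) + (-4)*m^4*(u 0 1)^4*(u 1 0)*(u 2 0)*(u 1 2)
    + 36*m^4*(u 0 1)^4*(u 1 0)*(u 1 1)*(u 2 1) + 4*m^4*(u 0 1)^4*(u 1 0)*(u 1 1)*(u 0 3)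
    + (-4)*m^4*(u 0 1)^4*(u 1 0)*(u 1 1)*(u 2 0) + (-8)*m^4*(u 0 1)^4*(u 1 0)*(u 0 2)*(u 3 0)
    + 8*m^4*(u 0 1)^4*(u 1 0)*(u 0 2)*(u 1 2) + (-4)*m^4*(u 0 1)^4*(u 1 0)*(u 0 2)*(u 1 1)
    + (-12)*m^4*(u 0 1)^4*(u 1 0)^2*(u 2 1) + 4*m^4*(u 0 1)^4*(u 1 0)^2*(u 0 3)
    + 24*m^4*(u 0 1)^4*(u 1 0)^2*(u 2 0) + (-24)*m^4*(u 0 1)^4*(u 1 0)^2*(u 0 2)
    + 6*m^4*(u 0 1)^5*(u 1 0)*(u 3 0) + (-2)*m^4*(u 0 1)^5*(u 1 0)*(u 1 2)
    + 32*m^4*(u 0 1)^5*(u 1 0)*(u 1 1) + 6*m^4*(u 0 1)^5*(u 1 0)^2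
    + (-8)*x*m^4*(u 0 1)^3*(u 1 0)^2*(u 1 1)*(u 2 0)
    + (-8)*x*m^4*(u 0 1)^3*(u 1 0)^2*(u 0 2)*(u 1 1) + (-4)*x*m^4*(u 0 1)^3*(u 1 0)^3*(u 2 1)
    + 12*x*m^4*(u 0 1)^3*(u 1 0)^3*(u 0 3) + 16*x*m^4*(u 0 1)^3*(u 1 0)^3*(u 2 0)
    + (-16)*x*m^4*(u 0 1)^3*(u 1 0)^3*(u 0 2) + 24*x*m^4*(u 0 1)^4*(u 1 0)*(u 2 0)^2
    + 64*x*m^4*(u 0 1)^4*(u 1 0)*(u 1 1)^2 + (-24)*x*m^4*(u 0 1)^4*(u 1 0)*(u 0 2)*(u 2 0)
    + 16*x*m^4*(u 0 1)^4*(u 1 0)*(u 0 2)^2 + 8*x*m^4*(u 0 1)^4*(u 1 0)^2*(u 3 0)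
    + (-24)*x*m^4*(u 0 1)^4*(u 1 0)^2*(u 1 2) + 28*x*m^4*(u 0 1)^4*(u 1 0)^3
    + 20*x*m^4*(u 0 1)^5*(u 1 0)*(u 2 1) + 4*x*m^4*(u 0 1)^5*(u 1 0)*(u 0 3)
    + 16*x*m^4*(u 0 1)^5*(u 1 0)*(u 2 0) + (-16)*x*m^4*(u 0 1)^5*(u 1 0)*(u 0 2)
    + 28*x*m^4*(u 0 1)^6*(u 1 0) + 8*x^2*m^4*(u 0 1)^3*(u 1 0)^4
    + 32*x^2*m^4*(u 0 1)^4*(u 1 0)^2*(u 2 0) + (-32)*x^2*m^4*(u 0 1)^4*(u 1 0)^2*(u 0 2)
    + 64*x^2*m^4*(u 0 1)^5*(u 1 0)*(u 1 1) + 8*x^2*m^4*(u 0 1)^5*(u 1 0)^2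
    + 16*x^3*m^4*(u 0 1)^4*(u 1 0)^3 + 16*x^3*m^4*(u 0 1)^6*(u 1 0).

Definition elim4 :=
  2*m^2*(u 0 1)*(u 1 0)*(u 1 1)*(u 2 0) + 2*m^2*(u 0 1)*(u 1 0)*(u 0 2)*(u 1 1)
    + (-2)*m^2*(u 0 1)*(u 1 0)^2*(u 0 3) + (-1)*m^2*(u 0 1)*(u 1 0)^2*(u 2 0)
    + 2*m^2*(u 0 1)*(u 1 0)^2*(u 0 2) + (-2)*m^2*(u 0 1)^2*(u 2 0)^2
    + (-4)*m^2*(u 0 1)^2*(u 1 1)^2 + 2*m^2*(u 0 1)^2*(u 0 2)*(u 2 0)
    + 4*m^2*(u 0 1)^2*(u 1 0)*(u 1 2) + (-2)*m^2*(u 0 1)^2*(u 1 0)*(u 1 1)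
    + (-2)*m^2*(u 0 1)^2*(u 1 0)^2 + (-2)*m^2*(u 0 1)^3*(u 2 1) + (-1)*m^2*(u 0 1)^3*(u 2 0)
    + (-2)*m^2*(u 0 1)^4 + 2*x*m^2*(u 0 1)*(u 1 0)^2*(u 1 1) + (-2)*x*m^2*(u 0 1)*(u 1 0)^3
    + (-4)*x*m^2*(u 0 1)^2*(u 1 0)*(u 2 0) + 8*x*m^2*(u 0 1)^2*(u 1 0)*(u 0 2)
    + (-10)*x*m^2*(u 0 1)^3*(u 1 1) + (-2)*x*m^2*(u 0 1)^3*(u 1 0)
    + (-4)*x^2*m^2*(u 0 1)^2*(u 1 0)^2 + (-4)*x^2*m^2*(u 0 1)^4.

Definition elim5 :=
  4*m^3*(u 0 1)^2*(u 1 0)^2*(u 1 1)*(u 2 0) + 4*m^3*(u 0 1)^2*(u 1 0)^2*(u 0 2)*(u 1 1)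
    + (-4)*m^3*(u 0 1)^2*(u 1 0)^3*(u 0 3) + (-2)*m^3*(u 0 1)^2*(u 1 0)^3*(u 2 0)
    + 4*m^3*(u 0 1)^2*(u 1 0)^3*(u 0 2) + (-4)*m^3*(u 0 1)^3*(u 1 0)*(u 2 0)^2
    + (-16)*m^3*(u 0 1)^3*(u 1 0)*(u 1 1)^2 + 8*m^3*(u 0 1)^3*(u 1 0)*(u 0 2)*(u 2 0)
    + (-4)*m^3*(u 0 1)^3*(u 1 0)*(u 0 2)^2 + 4*m^3*(u 0 1)^3*(u 1 0)^2*(u 1 2)
    + 6*m^3*(u 0 1)^3*(u 1 0)^2*(u 1 1) + (-6)*m^3*(u 0 1)^3*(u 1 0)^3
    + 4*m^3*(u 0 1)^4*(u 1 1)*(u 2 0) + 4*m^3*(u 0 1)^4*(u 0 2)*(u 1 1)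
    + (-4)*m^3*(u 0 1)^4*(u 1 0)*(u 0 3) + (-6)*m^3*(u 0 1)^4*(u 1 0)*(u 2 0)
    + 8*m^3*(u 0 1)^4*(u 1 0)*(u 0 2) + 4*m^3*(u 0 1)^5*(u 1 2) + (-2)*m^3*(u 0 1)^5*(u 1 1)
    + (-6)*m^3*(u 0 1)^5*(u 1 0) + 4*x*m^3*(u 0 1)^2*(u 1 0)^3*(u 1 1)
    + (-4)*x*m^3*(u 0 1)^2*(u 1 0)^4 + (-8)*x*m^3*(u 0 1)^3*(u 1 0)^2*(u 2 0)
    + 20*x*m^3*(u 0 1)^3*(u 1 0)^2*(u 0 2) + (-12)*x*m^3*(u 0 1)^4*(u 1 0)*(u 1 1)
    + (-8)*x*m^3*(u 0 1)^4*(u 1 0)^2 + 12*x*m^3*(u 0 1)^5*(u 0 2) + (-4)*x*m^3*(u 0 1)^6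
    + (-8)*x^2*m^3*(u 0 1)^3*(u 1 0)^3 + (-8)*x^2*m^3*(u 0 1)^5*(u 1 0).

Definition elim6 :=
  (-8)*m^5*(u 0 1)^3*(u 1 0)^3*(u 1 1)^2*(u 2 0)
    + (-8)*m^5*(u 0 1)^3*(u 1 0)^3*(u 0 2)*(u 1 1)^2
    + (-8)*m^5*(u 0 1)^3*(u 1 0)^4*(u 1 1)*(u 2 1) + 16*m^5*(u 0 1)^3*(u 1 0)^4*(u 1 1)*(u 2 0)
    + 4*m^5*(u 0 1)^3*(u 1 0)^4*(u 0 2)*(u 1 1) + 4*m^5*(u 0 1)^3*(u 1 0)^5*(u 2 1)
    + (-6)*m^5*(u 0 1)^3*(u 1 0)^5*(u 2 0) + 32*m^5*(u 0 1)^4*(u 1 0)^2*(u 1 1)*(u 2 0)^2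
    + 16*m^5*(u 0 1)^4*(u 1 0)^2*(u 1 1)^3 + (-16)*m^5*(u 0 1)^4*(u 1 0)^2*(u 0 2)^2*(u 1 1)
    + 8*m^5*(u 0 1)^4*(u 1 0)^3*(u 2 0)*(u 2 1) + 16*m^5*(u 0 1)^4*(u 1 0)^3*(u 2 0)*(u 0 3)
    + (-24)*m^5*(u 0 1)^4*(u 1 0)^3*(u 2 0)^2 + (-80)*m^5*(u 0 1)^4*(u 1 0)^3*(u 1 1)*(u 1 2)
    + 64*m^5*(u 0 1)^4*(u 1 0)^3*(u 1 1)^2 + (-8)*m^5*(u 0 1)^4*(u 1 0)^3*(u 0 2)*(u 2 1)
    + (-24)*m^5*(u 0 1)^4*(u 1 0)^3*(u 0 2)*(u 0 3) + 4*m^5*(u 0 1)^4*(u 1 0)^3*(u 0 2)*(u 2 0)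
    + 24*m^5*(u 0 1)^4*(u 1 0)^3*(u 0 2)^2 + 24*m^5*(u 0 1)^4*(u 1 0)^4*(u 1 2)
    + (-28)*m^5*(u 0 1)^4*(u 1 0)^4*(u 1 1) + 8*m^5*(u 0 1)^4*(u 1 0)^5
    + (-24)*m^5*(u 0 1)^5*(u 1 0)*(u 2 0)^3 + (-48)*m^5*(u 0 1)^5*(u 1 0)*(u 1 1)^2*(u 2 0)
    + 40*m^5*(u 0 1)^5*(u 1 0)*(u 0 2)*(u 2 0)^2 + 32*m^5*(u 0 1)^5*(u 1 0)*(u 0 2)*(u 1 1)^2
    + (-16)*m^5*(u 0 1)^5*(u 1 0)*(u 0 2)^2*(u 2 0) + 16*m^5*(u 0 1)^5*(u 1 0)^2*(u 2 0)*(u 1 2)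
    + 80*m^5*(u 0 1)^5*(u 1 0)^2*(u 1 1)*(u 2 1) + 8*m^5*(u 0 1)^5*(u 1 0)^2*(u 1 1)*(u 0 3)
    + (-16)*m^5*(u 0 1)^5*(u 1 0)^2*(u 1 1)*(u 2 0) + 20*m^5*(u 0 1)^5*(u 1 0)^2*(u 0 2)*(u 1 1)
    + (-16)*m^5*(u 0 1)^5*(u 1 0)^3*(u 2 1) + 8*m^5*(u 0 1)^5*(u 1 0)^3*(u 0 3)
    + 4*m^5*(u 0 1)^5*(u 1 0)^3*(u 2 0) + (-32)*m^5*(u 0 1)^5*(u 1 0)^3*(u 0 2)
    + (-24)*m^5*(u 0 1)^6*(u 1 0)*(u 2 0)*(u 2 1) + (-24)*m^5*(u 0 1)^6*(u 1 0)*(u 2 0)^2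
    + (-24)*m^5*(u 0 1)^6*(u 1 0)*(u 1 1)^2 + 16*m^5*(u 0 1)^6*(u 1 0)*(u 0 2)*(u 2 1)
    + 20*m^5*(u 0 1)^6*(u 1 0)*(u 0 2)*(u 2 0) + 8*m^5*(u 0 1)^6*(u 1 0)^2*(u 1 2)
    + 60*m^5*(u 0 1)^6*(u 1 0)^2*(u 1 1) + (-4)*m^5*(u 0 1)^6*(u 1 0)^3
    + (-12)*m^5*(u 0 1)^7*(u 1 0)*(u 2 1) + (-30)*m^5*(u 0 1)^7*(u 1 0)*(u 2 0)
    + 16*m^5*(u 0 1)^7*(u 1 0)*(u 0 2) + (-12)*m^5*(u 0 1)^8*(u 1 0)
    + (-8)*x*m^5*(u 0 1)^3*(u 1 0)^4*(u 1 1)^2 + 12*x*m^5*(u 0 1)^3*(u 1 0)^5*(u 1 1)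
    + (-4)*x*m^5*(u 0 1)^3*(u 1 0)^6 + 56*x*m^5*(u 0 1)^4*(u 1 0)^3*(u 1 1)*(u 2 0)
    + (-32)*x*m^5*(u 0 1)^4*(u 1 0)^3*(u 0 2)*(u 1 1) + 8*x*m^5*(u 0 1)^4*(u 1 0)^4*(u 2 1)
    + 24*x*m^5*(u 0 1)^4*(u 1 0)^4*(u 0 3) + (-32)*x*m^5*(u 0 1)^4*(u 1 0)^4*(u 2 0)
    + (-8)*x*m^5*(u 0 1)^4*(u 1 0)^4*(u 0 2) + (-64)*x*m^5*(u 0 1)^5*(u 1 0)^2*(u 2 0)^2
    + 136*x*m^5*(u 0 1)^5*(u 1 0)^2*(u 1 1)^2 + 80*x*m^5*(u 0 1)^5*(u 1 0)^2*(u 0 2)*(u 2 0)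
    + (-32)*x*m^5*(u 0 1)^5*(u 1 0)^3*(u 1 2) + (-16)*x*m^5*(u 0 1)^5*(u 1 0)^3*(u 1 1)
    + 24*x*m^5*(u 0 1)^5*(u 1 0)^4 + (-120)*x*m^5*(u 0 1)^6*(u 1 0)*(u 1 1)*(u 2 0)
    + 80*x*m^5*(u 0 1)^6*(u 1 0)*(u 0 2)*(u 1 1) + 24*x*m^5*(u 0 1)^6*(u 1 0)^2*(u 2 1)
    + 8*x*m^5*(u 0 1)^6*(u 1 0)^2*(u 0 3) + (-48)*x*m^5*(u 0 1)^6*(u 1 0)^2*(u 2 0)
    + 8*x*m^5*(u 0 1)^6*(u 1 0)^2*(u 0 2) + (-60)*x*m^5*(u 0 1)^7*(u 1 0)*(u 1 1)
    + 28*x*m^5*(u 0 1)^7*(u 1 0)^2 + 32*x^2*m^5*(u 0 1)^4*(u 1 0)^4*(u 1 1)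
    + (-8)*x^2*m^5*(u 0 1)^4*(u 1 0)^5 + (-48)*x^2*m^5*(u 0 1)^5*(u 1 0)^3*(u 2 0)
    + 64*x^2*m^5*(u 0 1)^6*(u 1 0)^2*(u 1 1) + (-32)*x^2*m^5*(u 0 1)^6*(u 1 0)^3
    + (-48)*x^2*m^5*(u 0 1)^7*(u 1 0)*(u 2 0) + 32*x^2*m^5*(u 0 1)^7*(u 1 0)*(u 0 2)
    + (-24)*x^2*m^5*(u 0 1)^8*(u 1 0).

Definition elim7 :=
  (-32)*m^6*(u 0 1)^3*(u 1 0)^5*(u 1 1)^3 + 16*m^6*(u 0 1)^3*(u 1 0)^5*(u 0 2)*(u 1 1)*(u 2 0)
    + (-16)*m^6*(u 0 1)^3*(u 1 0)^5*(u 0 2)^2*(u 1 1)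
    + (-16)*m^6*(u 0 1)^3*(u 1 0)^6*(u 1 1)*(u 1 2) + 56*m^6*(u 0 1)^3*(u 1 0)^6*(u 1 1)^2
    + (-8)*m^6*(u 0 1)^3*(u 1 0)^6*(u 0 2)*(u 2 0) + 8*m^6*(u 0 1)^3*(u 1 0)^6*(u 0 2)^2
    + 8*m^6*(u 0 1)^3*(u 1 0)^7*(u 1 2) + (-28)*m^6*(u 0 1)^3*(u 1 0)^7*(u 1 1)
    + 4*m^6*(u 0 1)^3*(u 1 0)^8 + 32*m^6*(u 0 1)^4*(u 1 0)^4*(u 1 1)^2*(u 2 0)
    + (-16)*m^6*(u 0 1)^4*(u 1 0)^4*(u 0 2)*(u 2 0)^2
    + (-32)*m^6*(u 0 1)^4*(u 1 0)^4*(u 0 2)*(u 1 1)^2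
    + 32*m^6*(u 0 1)^4*(u 1 0)^4*(u 0 2)^2*(u 2 0) + (-16)*m^6*(u 0 1)^4*(u 1 0)^4*(u 0 2)^3
    + 16*m^6*(u 0 1)^4*(u 1 0)^5*(u 2 0)*(u 1 2) + (-16)*m^6*(u 0 1)^4*(u 1 0)^5*(u 1 1)*(u 0 3)
    + (-32)*m^6*(u 0 1)^4*(u 1 0)^5*(u 1 1)*(u 2 0)
    + (-16)*m^6*(u 0 1)^4*(u 1 0)^5*(u 0 2)*(u 1 2) + 72*m^6*(u 0 1)^4*(u 1 0)^5*(u 0 2)*(u 1 1)
    + 8*m^6*(u 0 1)^4*(u 1 0)^6*(u 0 3) + 4*m^6*(u 0 1)^4*(u 1 0)^6*(u 2 0)
    + (-24)*m^6*(u 0 1)^4*(u 1 0)^6*(u 0 2) + 48*m^6*(u 0 1)^5*(u 1 0)^3*(u 1 1)*(u 2 0)^2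
    + 352*m^6*(u 0 1)^5*(u 1 0)^3*(u 1 1)^3
    + (-160)*m^6*(u 0 1)^5*(u 1 0)^3*(u 0 2)*(u 1 1)*(u 2 0)
    + 144*m^6*(u 0 1)^5*(u 1 0)^3*(u 0 2)^2*(u 1 1) + 48*m^6*(u 0 1)^5*(u 1 0)^4*(u 2 0)*(u 0 3)
    + (-32)*m^6*(u 0 1)^5*(u 1 0)^4*(u 2 0)^2 + 16*m^6*(u 0 1)^5*(u 1 0)^4*(u 1 1)*(u 1 2)
    + (-344)*m^6*(u 0 1)^5*(u 1 0)^4*(u 1 1)^2 + (-64)*m^6*(u 0 1)^5*(u 1 0)^4*(u 0 2)*(u 0 3)
    + (-8)*m^6*(u 0 1)^5*(u 1 0)^4*(u 0 2)*(u 2 0) + 48*m^6*(u 0 1)^5*(u 1 0)^4*(u 0 2)^2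
    + 8*m^6*(u 0 1)^5*(u 1 0)^5*(u 1 2) + 100*m^6*(u 0 1)^5*(u 1 0)^5*(u 1 1)
    + 4*m^6*(u 0 1)^5*(u 1 0)^6 + (-48)*m^6*(u 0 1)^6*(u 1 0)^2*(u 2 0)^3
    + (-352)*m^6*(u 0 1)^6*(u 1 0)^2*(u 1 1)^2*(u 2 0)
    + 128*m^6*(u 0 1)^6*(u 1 0)^2*(u 0 2)*(u 2 0)^2
    + (-32)*m^6*(u 0 1)^6*(u 1 0)^2*(u 0 2)*(u 1 1)^2
    + (-112)*m^6*(u 0 1)^6*(u 1 0)^2*(u 0 2)^2*(u 2 0) + 32*m^6*(u 0 1)^6*(u 1 0)^2*(u 0 2)^3
    + (-32)*m^6*(u 0 1)^6*(u 1 0)^3*(u 2 0)*(u 1 2)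
    + 176*m^6*(u 0 1)^6*(u 1 0)^3*(u 1 1)*(u 0 3) + 288*m^6*(u 0 1)^6*(u 1 0)^3*(u 1 1)*(u 2 0)
    + 48*m^6*(u 0 1)^6*(u 1 0)^3*(u 0 2)*(u 1 2)
    + (-336)*m^6*(u 0 1)^6*(u 1 0)^3*(u 0 2)*(u 1 1) + (-16)*m^6*(u 0 1)^6*(u 1 0)^4*(u 0 3)
    + (-40)*m^6*(u 0 1)^6*(u 1 0)^4*(u 2 0) + 8*m^6*(u 0 1)^6*(u 1 0)^4*(u 0 2)
    + 48*m^6*(u 0 1)^7*(u 1 0)*(u 1 1)*(u 2 0)^2
    + 16*m^6*(u 0 1)^7*(u 1 0)*(u 0 2)*(u 1 1)*(u 2 0)
    + (-32)*m^6*(u 0 1)^7*(u 1 0)*(u 0 2)^2*(u 1 1)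
    + (-48)*m^6*(u 0 1)^7*(u 1 0)^2*(u 2 0)*(u 0 3) + (-96)*m^6*(u 0 1)^7*(u 1 0)^2*(u 2 0)^2
    + (-160)*m^6*(u 0 1)^7*(u 1 0)^2*(u 1 1)*(u 1 2) + (-16)*m^6*(u 0 1)^7*(u 1 0)^2*(u 1 1)^2
    + 32*m^6*(u 0 1)^7*(u 1 0)^2*(u 0 2)*(u 0 3) + 192*m^6*(u 0 1)^7*(u 1 0)^2*(u 0 2)*(u 2 0)
    + (-88)*m^6*(u 0 1)^7*(u 1 0)^2*(u 0 2)^2 + 24*m^6*(u 0 1)^7*(u 1 0)^3*(u 1 2)
    + 244*m^6*(u 0 1)^7*(u 1 0)^3*(u 1 1) + (-36)*m^6*(u 0 1)^7*(u 1 0)^4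
    + 48*m^6*(u 0 1)^8*(u 1 0)*(u 2 0)*(u 1 2) + (-32)*m^6*(u 0 1)^8*(u 1 0)*(u 0 2)*(u 1 2)
    + 40*m^6*(u 0 1)^8*(u 1 0)*(u 0 2)*(u 1 1) + (-24)*m^6*(u 0 1)^8*(u 1 0)^2*(u 0 3)
    + (-108)*m^6*(u 0 1)^8*(u 1 0)^2*(u 2 0) + 96*m^6*(u 0 1)^8*(u 1 0)^2*(u 0 2)
    + 24*m^6*(u 0 1)^9*(u 1 0)*(u 1 2) + (-12)*m^6*(u 0 1)^9*(u 1 0)*(u 1 1)
    + (-36)*m^6*(u 0 1)^9*(u 1 0)^2 + 16*x*m^6*(u 0 1)^3*(u 1 0)^6*(u 0 2)*(u 1 1)
    + (-8)*x*m^6*(u 0 1)^3*(u 1 0)^7*(u 0 2) + 48*x*m^6*(u 0 1)^4*(u 1 0)^5*(u 1 1)^2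
    + (-32)*x*m^6*(u 0 1)^4*(u 1 0)^5*(u 0 2)*(u 2 0) + 32*x*m^6*(u 0 1)^4*(u 1 0)^5*(u 0 2)^2
    + 16*x*m^6*(u 0 1)^4*(u 1 0)^6*(u 1 2) + (-48)*x*m^6*(u 0 1)^4*(u 1 0)^6*(u 1 1)
    + 8*x*m^6*(u 0 1)^4*(u 1 0)^7 + 64*x*m^6*(u 0 1)^5*(u 1 0)^4*(u 1 1)*(u 2 0)
    + (-160)*x*m^6*(u 0 1)^5*(u 1 0)^4*(u 0 2)*(u 1 1) + 64*x*m^6*(u 0 1)^5*(u 1 0)^5*(u 0 3)
    + (-32)*x*m^6*(u 0 1)^5*(u 1 0)^5*(u 2 0) + (-56)*x*m^6*(u 0 1)^5*(u 1 0)^5*(u 0 2)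
    + (-128)*x*m^6*(u 0 1)^6*(u 1 0)^3*(u 2 0)^2 + 48*x*m^6*(u 0 1)^6*(u 1 0)^3*(u 1 1)^2
    + 112*x*m^6*(u 0 1)^6*(u 1 0)^3*(u 0 2)*(u 2 0) + 64*x*m^6*(u 0 1)^6*(u 1 0)^3*(u 0 2)^2
    + (-32)*x*m^6*(u 0 1)^6*(u 1 0)^4*(u 1 2) + 64*x*m^6*(u 0 1)^6*(u 1 0)^4*(u 1 1)
    + 56*x*m^6*(u 0 1)^6*(u 1 0)^5 + (-192)*x*m^6*(u 0 1)^7*(u 1 0)^2*(u 1 1)*(u 2 0)
    + (-432)*x*m^6*(u 0 1)^7*(u 1 0)^2*(u 0 2)*(u 1 1) + 64*x*m^6*(u 0 1)^7*(u 1 0)^3*(u 0 3)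
    + (-80)*x*m^6*(u 0 1)^7*(u 1 0)^3*(u 2 0) + 56*x*m^6*(u 0 1)^7*(u 1 0)^3*(u 0 2)
    + 144*x*m^6*(u 0 1)^8*(u 1 0)*(u 0 2)*(u 2 0) + (-96)*x*m^6*(u 0 1)^8*(u 1 0)*(u 0 2)^2
    + (-48)*x*m^6*(u 0 1)^8*(u 1 0)^2*(u 1 2) + 112*x*m^6*(u 0 1)^8*(u 1 0)^2*(u 1 1)
    + 24*x*m^6*(u 0 1)^8*(u 1 0)^3 + (-48)*x*m^6*(u 0 1)^9*(u 1 0)*(u 2 0)
    + 104*x*m^6*(u 0 1)^9*(u 1 0)*(u 0 2) + (-24)*x*m^6*(u 0 1)^10*(u 1 0)
    + (-16)*x^2*m^6*(u 0 1)^4*(u 1 0)^6*(u 0 2) + 32*x^2*m^6*(u 0 1)^5*(u 1 0)^5*(u 1 1)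
    + (-96)*x^2*m^6*(u 0 1)^6*(u 1 0)^4*(u 2 0) + (-96)*x^2*m^6*(u 0 1)^6*(u 1 0)^4*(u 0 2)
    + 32*x^2*m^6*(u 0 1)^7*(u 1 0)^3*(u 1 1) + (-96)*x^2*m^6*(u 0 1)^8*(u 1 0)^2*(u 2 0)
    + (-80)*x^2*m^6*(u 0 1)^8*(u 1 0)^2*(u 0 2).

Definition elim8 :=
  128*m^9*(u 0 1)^5*(u 1 0)^8*(u 1 1)^3 + (-64)*m^9*(u 0 1)^5*(u 1 0)^8*(u 0 2)*(u 1 1)*(u 2 0)
    + 64*m^9*(u 0 1)^5*(u 1 0)^8*(u 0 2)^2*(u 1 1) + 64*m^9*(u 0 1)^5*(u 1 0)^9*(u 1 1)*(u 1 2)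
    + (-224)*m^9*(u 0 1)^5*(u 1 0)^9*(u 1 1)^2 + 32*m^9*(u 0 1)^5*(u 1 0)^9*(u 0 2)*(u 2 0)
    + (-32)*m^9*(u 0 1)^5*(u 1 0)^9*(u 0 2)^2 + (-32)*m^9*(u 0 1)^5*(u 1 0)^10*(u 1 2)
    + 112*m^9*(u 0 1)^5*(u 1 0)^10*(u 1 1) + (-16)*m^9*(u 0 1)^5*(u 1 0)^11
    + (-64)*m^9*(u 0 1)^6*(u 1 0)^7*(u 1 1)^2*(u 2 0)
    + 64*m^9*(u 0 1)^6*(u 1 0)^7*(u 0 2)*(u 2 0)^2
    + 192*m^9*(u 0 1)^6*(u 1 0)^7*(u 0 2)*(u 1 1)^2
    + (-128)*m^9*(u 0 1)^6*(u 1 0)^7*(u 0 2)^2*(u 2 0) + 64*m^9*(u 0 1)^6*(u 1 0)^7*(u 0 2)^3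
    + (-64)*m^9*(u 0 1)^6*(u 1 0)^8*(u 2 0)*(u 1 2) + 64*m^9*(u 0 1)^6*(u 1 0)^8*(u 1 1)*(u 2 0)
    + 64*m^9*(u 0 1)^6*(u 1 0)^8*(u 0 2)*(u 1 2)
    + (-256)*m^9*(u 0 1)^6*(u 1 0)^8*(u 0 2)*(u 1 1) + 64*m^9*(u 0 1)^6*(u 1 0)^9*(u 0 2)
    + (-448)*m^9*(u 0 1)^7*(u 1 0)^6*(u 1 1)*(u 2 0)^2
    + (-1536)*m^9*(u 0 1)^7*(u 1 0)^6*(u 1 1)^3
    + 768*m^9*(u 0 1)^7*(u 1 0)^6*(u 0 2)*(u 1 1)*(u 2 0)
    + (-320)*m^9*(u 0 1)^7*(u 1 0)^6*(u 0 2)^2*(u 1 1) + 256*m^9*(u 0 1)^7*(u 1 0)^7*(u 2 0)^2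
    + 64*m^9*(u 0 1)^7*(u 1 0)^7*(u 1 1)*(u 1 2) + 1376*m^9*(u 0 1)^7*(u 1 0)^7*(u 1 1)^2
    + (-320)*m^9*(u 0 1)^7*(u 1 0)^7*(u 0 2)*(u 2 0) + 64*m^9*(u 0 1)^7*(u 1 0)^7*(u 0 2)^2
    + (-96)*m^9*(u 0 1)^7*(u 1 0)^8*(u 1 2) + (-432)*m^9*(u 0 1)^7*(u 1 0)^8*(u 1 1)
    + 16*m^9*(u 0 1)^7*(u 1 0)^9 + 384*m^9*(u 0 1)^8*(u 1 0)^5*(u 2 0)^3
    + 1408*m^9*(u 0 1)^8*(u 1 0)^5*(u 1 1)^2*(u 2 0)
    + (-1088)*m^9*(u 0 1)^8*(u 1 0)^5*(u 0 2)*(u 2 0)^2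
    + (-1408)*m^9*(u 0 1)^8*(u 1 0)^5*(u 0 2)*(u 1 1)^2
    + 1024*m^9*(u 0 1)^8*(u 1 0)^5*(u 0 2)^2*(u 2 0) + (-320)*m^9*(u 0 1)^8*(u 1 0)^5*(u 0 2)^3
    + (-128)*m^9*(u 0 1)^8*(u 1 0)^6*(u 2 0)*(u 1 2)
    + (-1024)*m^9*(u 0 1)^8*(u 1 0)^6*(u 1 1)*(u 2 0)
    + 128*m^9*(u 0 1)^8*(u 1 0)^6*(u 0 2)*(u 1 2) + 896*m^9*(u 0 1)^8*(u 1 0)^6*(u 0 2)*(u 1 1)
    + 448*m^9*(u 0 1)^8*(u 1 0)^7*(u 2 0) + (-320)*m^9*(u 0 1)^8*(u 1 0)^7*(u 0 2)
    + 320*m^9*(u 0 1)^9*(u 1 0)^4*(u 1 1)*(u 2 0)^2 + 1408*m^9*(u 0 1)^9*(u 1 0)^4*(u 1 1)^3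
    + (-704)*m^9*(u 0 1)^9*(u 1 0)^4*(u 0 2)*(u 1 1)*(u 2 0)
    + 384*m^9*(u 0 1)^9*(u 1 0)^4*(u 0 2)^2*(u 1 1) + 640*m^9*(u 0 1)^9*(u 1 0)^5*(u 2 0)^2
    + (-64)*m^9*(u 0 1)^9*(u 1 0)^5*(u 1 1)*(u 1 2) + 96*m^9*(u 0 1)^9*(u 1 0)^5*(u 1 1)^2
    + (-1120)*m^9*(u 0 1)^9*(u 1 0)^5*(u 0 2)*(u 2 0) + 480*m^9*(u 0 1)^9*(u 1 0)^5*(u 0 2)^2
    + (-96)*m^9*(u 0 1)^9*(u 1 0)^6*(u 1 2) + (-304)*m^9*(u 0 1)^9*(u 1 0)^6*(u 1 1)
    + 80*m^9*(u 0 1)^9*(u 1 0)^7 + (-64)*m^9*(u 0 1)^10*(u 1 0)^3*(u 1 1)^2*(u 2 0)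
    + (-64)*m^9*(u 0 1)^10*(u 1 0)^3*(u 0 2)*(u 1 1)^2
    + (-64)*m^9*(u 0 1)^10*(u 1 0)^4*(u 2 0)*(u 1 2)
    + 448*m^9*(u 0 1)^10*(u 1 0)^4*(u 1 1)*(u 2 0) + 64*m^9*(u 0 1)^10*(u 1 0)^4*(u 0 2)*(u 1 2)
    + (-384)*m^9*(u 0 1)^10*(u 1 0)^4*(u 0 2)*(u 1 1) + 448*m^9*(u 0 1)^10*(u 1 0)^5*(u 2 0)
    + (-384)*m^9*(u 0 1)^10*(u 1 0)^5*(u 0 2) + (-64)*m^9*(u 0 1)^11*(u 1 0)^3*(u 1 1)*(u 1 2)
    + 32*m^9*(u 0 1)^11*(u 1 0)^3*(u 1 1)^2 + (-32)*m^9*(u 0 1)^11*(u 1 0)^4*(u 1 2)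
    + 240*m^9*(u 0 1)^11*(u 1 0)^4*(u 1 1) + 48*m^9*(u 0 1)^11*(u 1 0)^5
    + (-64)*x*m^9*(u 0 1)^5*(u 1 0)^9*(u 0 2)*(u 1 1) + 32*x*m^9*(u 0 1)^5*(u 1 0)^10*(u 0 2)
    + (-128)*x*m^9*(u 0 1)^6*(u 1 0)^8*(u 1 1)^2 + 128*x*m^9*(u 0 1)^6*(u 1 0)^8*(u 0 2)*(u 2 0)
    + (-128)*x*m^9*(u 0 1)^6*(u 1 0)^8*(u 0 2)^2 + (-64)*x*m^9*(u 0 1)^6*(u 1 0)^9*(u 1 2)
    + 96*x*m^9*(u 0 1)^6*(u 1 0)^9*(u 1 1) + (-832)*x*m^9*(u 0 1)^7*(u 1 0)^7*(u 1 1)*(u 2 0)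
    + 896*x*m^9*(u 0 1)^7*(u 1 0)^7*(u 0 2)*(u 1 1) + 512*x*m^9*(u 0 1)^7*(u 1 0)^8*(u 2 0)
    + (-416)*x*m^9*(u 0 1)^7*(u 1 0)^8*(u 0 2) + 1152*x*m^9*(u 0 1)^8*(u 1 0)^6*(u 2 0)^2
    + (-256)*x*m^9*(u 0 1)^8*(u 1 0)^6*(u 1 1)^2
    + (-2304)*x*m^9*(u 0 1)^8*(u 1 0)^6*(u 0 2)*(u 2 0)
    + 1152*x*m^9*(u 0 1)^8*(u 1 0)^6*(u 0 2)^2 + (-192)*x*m^9*(u 0 1)^8*(u 1 0)^7*(u 1 2)
    + 288*x*m^9*(u 0 1)^8*(u 1 0)^7*(u 1 1) + 128*x*m^9*(u 0 1)^8*(u 1 0)^8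
    + 2176*x*m^9*(u 0 1)^9*(u 1 0)^5*(u 1 1)*(u 2 0)
    + (-2368)*x*m^9*(u 0 1)^9*(u 1 0)^5*(u 0 2)*(u 1 1) + 1024*x*m^9*(u 0 1)^9*(u 1 0)^6*(u 2 0)
    + (-928)*x*m^9*(u 0 1)^9*(u 1 0)^6*(u 0 2) + 384*x*m^9*(u 0 1)^10*(u 1 0)^4*(u 2 0)^2
    + 2944*x*m^9*(u 0 1)^10*(u 1 0)^4*(u 1 1)^2
    + (-896)*x*m^9*(u 0 1)^10*(u 1 0)^4*(u 0 2)*(u 2 0)
    + 512*x*m^9*(u 0 1)^10*(u 1 0)^4*(u 0 2)^2 + (-192)*x*m^9*(u 0 1)^10*(u 1 0)^5*(u 1 2)
    + 288*x*m^9*(u 0 1)^10*(u 1 0)^5*(u 1 1) + 256*x*m^9*(u 0 1)^10*(u 1 0)^6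
    + (-64)*x*m^9*(u 0 1)^11*(u 1 0)^3*(u 1 1)*(u 2 0)
    + (-256)*x*m^9*(u 0 1)^11*(u 1 0)^3*(u 0 2)*(u 1 1) + 512*x*m^9*(u 0 1)^11*(u 1 0)^4*(u 2 0)
    + (-480)*x*m^9*(u 0 1)^11*(u 1 0)^4*(u 0 2) + (-64)*x*m^9*(u 0 1)^12*(u 1 0)^3*(u 1 2)
    + 96*x*m^9*(u 0 1)^12*(u 1 0)^3*(u 1 1) + 128*x*m^9*(u 0 1)^12*(u 1 0)^4
    + 64*x^2*m^9*(u 0 1)^6*(u 1 0)^9*(u 0 2) + (-512)*x^2*m^9*(u 0 1)^7*(u 1 0)^8*(u 1 1)
    + 320*x^2*m^9*(u 0 1)^7*(u 1 0)^9 + 1280*x^2*m^9*(u 0 1)^8*(u 1 0)^7*(u 2 0)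
    + (-1344)*x^2*m^9*(u 0 1)^8*(u 1 0)^7*(u 0 2) + 1536*x^2*m^9*(u 0 1)^9*(u 1 0)^6*(u 1 1)
    + 704*x^2*m^9*(u 0 1)^9*(u 1 0)^7 + 1280*x^2*m^9*(u 0 1)^10*(u 1 0)^5*(u 2 0)
    + (-1600)*x^2*m^9*(u 0 1)^10*(u 1 0)^5*(u 0 2) + 2048*x^2*m^9*(u 0 1)^11*(u 1 0)^4*(u 1 1)
    + 448*x^2*m^9*(u 0 1)^11*(u 1 0)^5 + (-192)*x^2*m^9*(u 0 1)^12*(u 1 0)^3*(u 0 2)
    + 64*x^2*m^9*(u 0 1)^13*(u 1 0)^3 + 512*x^3*m^9*(u 0 1)^8*(u 1 0)^8
    + 1024*x^3*m^9*(u 0 1)^10*(u 1 0)^6 + 512*x^3*m^9*(u 0 1)^12*(u 1 0)^4.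

Definition elim9 :=
  256*m^10*(u 0 1)^6*(u 1 0)^9*(u 1 1)^3
    + (-128)*m^10*(u 0 1)^6*(u 1 0)^9*(u 0 2)*(u 1 1)*(u 2 0)
    + 128*m^10*(u 0 1)^6*(u 1 0)^9*(u 0 2)^2*(u 1 1)
    + 128*m^10*(u 0 1)^6*(u 1 0)^10*(u 1 1)*(u 1 2) + (-448)*m^10*(u 0 1)^6*(u 1 0)^10*(u 1 1)^2
    + 64*m^10*(u 0 1)^6*(u 1 0)^10*(u 0 2)*(u 2 0) + (-64)*m^10*(u 0 1)^6*(u 1 0)^10*(u 0 2)^2
    + (-64)*m^10*(u 0 1)^6*(u 1 0)^11*(u 1 2) + 224*m^10*(u 0 1)^6*(u 1 0)^11*(u 1 1)
    + (-32)*m^10*(u 0 1)^6*(u 1 0)^12 + (-128)*m^10*(u 0 1)^7*(u 1 0)^8*(u 1 1)^2*(u 2 0)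
    + 128*m^10*(u 0 1)^7*(u 1 0)^8*(u 0 2)*(u 2 0)^2
    + 384*m^10*(u 0 1)^7*(u 1 0)^8*(u 0 2)*(u 1 1)^2
    + (-256)*m^10*(u 0 1)^7*(u 1 0)^8*(u 0 2)^2*(u 2 0) + 128*m^10*(u 0 1)^7*(u 1 0)^8*(u 0 2)^3
    + (-128)*m^10*(u 0 1)^7*(u 1 0)^9*(u 2 0)*(u 1 2)
    + 128*m^10*(u 0 1)^7*(u 1 0)^9*(u 1 1)*(u 2 0)
    + 128*m^10*(u 0 1)^7*(u 1 0)^9*(u 0 2)*(u 1 2)
    + (-512)*m^10*(u 0 1)^7*(u 1 0)^9*(u 0 2)*(u 1 1) + 128*m^10*(u 0 1)^7*(u 1 0)^10*(u 0 2)
    + (-128)*m^10*(u 0 1)^8*(u 1 0)^7*(u 1 1)*(u 2 0)^2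
    + (-3072)*m^10*(u 0 1)^8*(u 1 0)^7*(u 1 1)^3
    + 1536*m^10*(u 0 1)^8*(u 1 0)^7*(u 0 2)*(u 1 1)*(u 2 0)
    + (-640)*m^10*(u 0 1)^8*(u 1 0)^7*(u 0 2)^2*(u 1 1) + 128*m^10*(u 0 1)^8*(u 1 0)^8*(u 2 0)^2
    + 128*m^10*(u 0 1)^8*(u 1 0)^8*(u 1 1)*(u 1 2) + 2752*m^10*(u 0 1)^8*(u 1 0)^8*(u 1 1)^2
    + (-640)*m^10*(u 0 1)^8*(u 1 0)^8*(u 0 2)*(u 2 0) + 128*m^10*(u 0 1)^8*(u 1 0)^8*(u 0 2)^2
    + (-192)*m^10*(u 0 1)^8*(u 1 0)^9*(u 1 2) + (-864)*m^10*(u 0 1)^8*(u 1 0)^9*(u 1 1)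
    + 32*m^10*(u 0 1)^8*(u 1 0)^10 + 2816*m^10*(u 0 1)^9*(u 1 0)^6*(u 1 1)^2*(u 2 0)
    + (-1408)*m^10*(u 0 1)^9*(u 1 0)^6*(u 0 2)*(u 2 0)^2
    + (-2816)*m^10*(u 0 1)^9*(u 1 0)^6*(u 0 2)*(u 1 1)^2
    + 2048*m^10*(u 0 1)^9*(u 1 0)^6*(u 0 2)^2*(u 2 0)
    + (-640)*m^10*(u 0 1)^9*(u 1 0)^6*(u 0 2)^3
    + (-256)*m^10*(u 0 1)^9*(u 1 0)^7*(u 2 0)*(u 1 2)
    + (-2048)*m^10*(u 0 1)^9*(u 1 0)^7*(u 1 1)*(u 2 0)
    + 256*m^10*(u 0 1)^9*(u 1 0)^7*(u 0 2)*(u 1 2)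
    + 1792*m^10*(u 0 1)^9*(u 1 0)^7*(u 0 2)*(u 1 1) + 896*m^10*(u 0 1)^9*(u 1 0)^8*(u 2 0)
    + (-640)*m^10*(u 0 1)^9*(u 1 0)^8*(u 0 2)
    + (-128)*m^10*(u 0 1)^10*(u 1 0)^5*(u 1 1)*(u 2 0)^2
    + 2816*m^10*(u 0 1)^10*(u 1 0)^5*(u 1 1)^3
    + (-1408)*m^10*(u 0 1)^10*(u 1 0)^5*(u 0 2)*(u 1 1)*(u 2 0)
    + 768*m^10*(u 0 1)^10*(u 1 0)^5*(u 0 2)^2*(u 1 1) + 896*m^10*(u 0 1)^10*(u 1 0)^6*(u 2 0)^2
    + (-128)*m^10*(u 0 1)^10*(u 1 0)^6*(u 1 1)*(u 1 2) + 192*m^10*(u 0 1)^10*(u 1 0)^6*(u 1 1)^2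
    + (-2240)*m^10*(u 0 1)^10*(u 1 0)^6*(u 0 2)*(u 2 0)
    + 960*m^10*(u 0 1)^10*(u 1 0)^6*(u 0 2)^2 + (-192)*m^10*(u 0 1)^10*(u 1 0)^7*(u 1 2)
    + (-608)*m^10*(u 0 1)^10*(u 1 0)^7*(u 1 1) + 160*m^10*(u 0 1)^10*(u 1 0)^8
    + (-128)*m^10*(u 0 1)^11*(u 1 0)^4*(u 1 1)^2*(u 2 0)
    + (-128)*m^10*(u 0 1)^11*(u 1 0)^4*(u 0 2)*(u 1 1)^2
    + (-128)*m^10*(u 0 1)^11*(u 1 0)^5*(u 2 0)*(u 1 2)
    + 896*m^10*(u 0 1)^11*(u 1 0)^5*(u 1 1)*(u 2 0)
    + 128*m^10*(u 0 1)^11*(u 1 0)^5*(u 0 2)*(u 1 2)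
    + (-768)*m^10*(u 0 1)^11*(u 1 0)^5*(u 0 2)*(u 1 1) + 896*m^10*(u 0 1)^11*(u 1 0)^6*(u 2 0)
    + (-768)*m^10*(u 0 1)^11*(u 1 0)^6*(u 0 2)
    + (-128)*m^10*(u 0 1)^12*(u 1 0)^4*(u 1 1)*(u 1 2) + 64*m^10*(u 0 1)^12*(u 1 0)^4*(u 1 1)^2
    + (-64)*m^10*(u 0 1)^12*(u 1 0)^5*(u 1 2) + 480*m^10*(u 0 1)^12*(u 1 0)^5*(u 1 1)
    + 96*m^10*(u 0 1)^12*(u 1 0)^6 + (-128)*x*m^10*(u 0 1)^6*(u 1 0)^10*(u 0 2)*(u 1 1)
    + 64*x*m^10*(u 0 1)^6*(u 1 0)^11*(u 0 2) + (-256)*x*m^10*(u 0 1)^7*(u 1 0)^9*(u 1 1)^2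
    + 256*x*m^10*(u 0 1)^7*(u 1 0)^9*(u 0 2)*(u 2 0)
    + (-256)*x*m^10*(u 0 1)^7*(u 1 0)^9*(u 0 2)^2 + (-128)*x*m^10*(u 0 1)^7*(u 1 0)^10*(u 1 2)
    + 192*x*m^10*(u 0 1)^7*(u 1 0)^10*(u 1 1)
    + (-1664)*x*m^10*(u 0 1)^8*(u 1 0)^8*(u 1 1)*(u 2 0)
    + 1792*x*m^10*(u 0 1)^8*(u 1 0)^8*(u 0 2)*(u 1 1) + 1024*x*m^10*(u 0 1)^8*(u 1 0)^9*(u 2 0)
    + (-832)*x*m^10*(u 0 1)^8*(u 1 0)^9*(u 0 2) + 1536*x*m^10*(u 0 1)^9*(u 1 0)^7*(u 2 0)^2
    + (-512)*x*m^10*(u 0 1)^9*(u 1 0)^7*(u 1 1)^2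
    + (-4608)*x*m^10*(u 0 1)^9*(u 1 0)^7*(u 0 2)*(u 2 0)
    + 2304*x*m^10*(u 0 1)^9*(u 1 0)^7*(u 0 2)^2 + (-384)*x*m^10*(u 0 1)^9*(u 1 0)^8*(u 1 2)
    + 576*x*m^10*(u 0 1)^9*(u 1 0)^8*(u 1 1) + 256*x*m^10*(u 0 1)^9*(u 1 0)^9
    + 4352*x*m^10*(u 0 1)^10*(u 1 0)^6*(u 1 1)*(u 2 0)
    + (-4736)*x*m^10*(u 0 1)^10*(u 1 0)^6*(u 0 2)*(u 1 1)
    + 2048*x*m^10*(u 0 1)^10*(u 1 0)^7*(u 2 0) + (-1856)*x*m^10*(u 0 1)^10*(u 1 0)^7*(u 0 2)
    + 5888*x*m^10*(u 0 1)^11*(u 1 0)^5*(u 1 1)^2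
    + (-1792)*x*m^10*(u 0 1)^11*(u 1 0)^5*(u 0 2)*(u 2 0)
    + 1024*x*m^10*(u 0 1)^11*(u 1 0)^5*(u 0 2)^2 + (-384)*x*m^10*(u 0 1)^11*(u 1 0)^6*(u 1 2)
    + 576*x*m^10*(u 0 1)^11*(u 1 0)^6*(u 1 1) + 512*x*m^10*(u 0 1)^11*(u 1 0)^7
    + (-128)*x*m^10*(u 0 1)^12*(u 1 0)^4*(u 1 1)*(u 2 0)
    + (-512)*x*m^10*(u 0 1)^12*(u 1 0)^4*(u 0 2)*(u 1 1)
    + 1024*x*m^10*(u 0 1)^12*(u 1 0)^5*(u 2 0) + (-960)*x*m^10*(u 0 1)^12*(u 1 0)^5*(u 0 2)
    + (-128)*x*m^10*(u 0 1)^13*(u 1 0)^4*(u 1 2) + 192*x*m^10*(u 0 1)^13*(u 1 0)^4*(u 1 1)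
    + 256*x*m^10*(u 0 1)^13*(u 1 0)^5 + 128*x^2*m^10*(u 0 1)^7*(u 1 0)^10*(u 0 2)
    + (-1024)*x^2*m^10*(u 0 1)^8*(u 1 0)^9*(u 1 1) + 640*x^2*m^10*(u 0 1)^8*(u 1 0)^10
    + 2560*x^2*m^10*(u 0 1)^9*(u 1 0)^8*(u 2 0) + (-2688)*x^2*m^10*(u 0 1)^9*(u 1 0)^8*(u 0 2)
    + 3072*x^2*m^10*(u 0 1)^10*(u 1 0)^7*(u 1 1) + 1408*x^2*m^10*(u 0 1)^10*(u 1 0)^8
    + 2560*x^2*m^10*(u 0 1)^11*(u 1 0)^6*(u 2 0) + (-3200)*x^2*m^10*(u 0 1)^11*(u 1 0)^6*(u 0 2)
    + 4096*x^2*m^10*(u 0 1)^12*(u 1 0)^5*(u 1 1) + 896*x^2*m^10*(u 0 1)^12*(u 1 0)^6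
    + (-384)*x^2*m^10*(u 0 1)^13*(u 1 0)^4*(u 0 2) + 128*x^2*m^10*(u 0 1)^14*(u 1 0)^4
    + 1024*x^3*m^10*(u 0 1)^9*(u 1 0)^9 + 2048*x^3*m^10*(u 0 1)^11*(u 1 0)^7
    + 1024*x^3*m^10*(u 0 1)^13*(u 1 0)^5.

Definition elim10 :=
  512*m^11*(u 0 1)^7*(u 1 0)^10*(u 1 1)^3 + 256*m^11*(u 0 1)^7*(u 1 0)^10*(u 0 2)^2*(u 1 1)
    + 256*m^11*(u 0 1)^7*(u 1 0)^11*(u 1 1)*(u 1 2) + (-896)*m^11*(u 0 1)^7*(u 1 0)^11*(u 1 1)^2
    + (-128)*m^11*(u 0 1)^7*(u 1 0)^11*(u 0 2)^2 + (-128)*m^11*(u 0 1)^7*(u 1 0)^12*(u 1 2)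
    + 448*m^11*(u 0 1)^7*(u 1 0)^12*(u 1 1) + (-64)*m^11*(u 0 1)^7*(u 1 0)^13
    + (-512)*m^11*(u 0 1)^8*(u 1 0)^9*(u 1 1)^2*(u 2 0)
    + 768*m^11*(u 0 1)^8*(u 1 0)^9*(u 0 2)*(u 1 1)^2
    + (-256)*m^11*(u 0 1)^8*(u 1 0)^9*(u 0 2)^2*(u 2 0) + 256*m^11*(u 0 1)^8*(u 1 0)^9*(u 0 2)^3
    + (-256)*m^11*(u 0 1)^8*(u 1 0)^10*(u 2 0)*(u 1 2)
    + 640*m^11*(u 0 1)^8*(u 1 0)^10*(u 1 1)*(u 2 0)
    + 256*m^11*(u 0 1)^8*(u 1 0)^10*(u 0 2)*(u 1 2)
    + (-1024)*m^11*(u 0 1)^8*(u 1 0)^10*(u 0 2)*(u 1 1)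
    + (-128)*m^11*(u 0 1)^8*(u 1 0)^11*(u 2 0) + 256*m^11*(u 0 1)^8*(u 1 0)^11*(u 0 2)
    + (-6144)*m^11*(u 0 1)^9*(u 1 0)^8*(u 1 1)^3
    + (-256)*m^11*(u 0 1)^9*(u 1 0)^8*(u 0 2)*(u 1 1)*(u 2 0)
    + (-1280)*m^11*(u 0 1)^9*(u 1 0)^8*(u 0 2)^2*(u 1 1)
    + 256*m^11*(u 0 1)^9*(u 1 0)^9*(u 1 1)*(u 1 2) + 5504*m^11*(u 0 1)^9*(u 1 0)^9*(u 1 1)^2
    + 256*m^11*(u 0 1)^9*(u 1 0)^9*(u 0 2)*(u 2 0) + 256*m^11*(u 0 1)^9*(u 1 0)^9*(u 0 2)^2
    + (-384)*m^11*(u 0 1)^9*(u 1 0)^10*(u 1 2) + (-1728)*m^11*(u 0 1)^9*(u 1 0)^10*(u 1 1)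
    + 64*m^11*(u 0 1)^9*(u 1 0)^11 + 5632*m^11*(u 0 1)^10*(u 1 0)^7*(u 1 1)^2*(u 2 0)
    + (-5632)*m^11*(u 0 1)^10*(u 1 0)^7*(u 0 2)*(u 1 1)^2
    + 1280*m^11*(u 0 1)^10*(u 1 0)^7*(u 0 2)^2*(u 2 0)
    + (-1280)*m^11*(u 0 1)^10*(u 1 0)^7*(u 0 2)^3
    + (-512)*m^11*(u 0 1)^10*(u 1 0)^8*(u 2 0)*(u 1 2)
    + (-2304)*m^11*(u 0 1)^10*(u 1 0)^8*(u 1 1)*(u 2 0)
    + 512*m^11*(u 0 1)^10*(u 1 0)^8*(u 0 2)*(u 1 2)
    + 3584*m^11*(u 0 1)^10*(u 1 0)^8*(u 0 2)*(u 1 1) + 768*m^11*(u 0 1)^10*(u 1 0)^9*(u 2 0)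
    + (-1280)*m^11*(u 0 1)^10*(u 1 0)^9*(u 0 2) + 5632*m^11*(u 0 1)^11*(u 1 0)^6*(u 1 1)^3
    + (-256)*m^11*(u 0 1)^11*(u 1 0)^6*(u 0 2)*(u 1 1)*(u 2 0)
    + 1536*m^11*(u 0 1)^11*(u 1 0)^6*(u 0 2)^2*(u 1 1)
    + (-256)*m^11*(u 0 1)^11*(u 1 0)^7*(u 1 1)*(u 1 2) + 384*m^11*(u 0 1)^11*(u 1 0)^7*(u 1 1)^2
    + (-1280)*m^11*(u 0 1)^11*(u 1 0)^7*(u 0 2)*(u 2 0)
    + 1920*m^11*(u 0 1)^11*(u 1 0)^7*(u 0 2)^2 + (-384)*m^11*(u 0 1)^11*(u 1 0)^8*(u 1 2)
    + (-1216)*m^11*(u 0 1)^11*(u 1 0)^8*(u 1 1) + 320*m^11*(u 0 1)^11*(u 1 0)^9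
    + (-256)*m^11*(u 0 1)^12*(u 1 0)^5*(u 0 2)*(u 1 1)^2
    + (-256)*m^11*(u 0 1)^12*(u 1 0)^6*(u 2 0)*(u 1 2)
    + 128*m^11*(u 0 1)^12*(u 1 0)^6*(u 1 1)*(u 2 0)
    + 256*m^11*(u 0 1)^12*(u 1 0)^6*(u 0 2)*(u 1 2)
    + (-1536)*m^11*(u 0 1)^12*(u 1 0)^6*(u 0 2)*(u 1 1) + 896*m^11*(u 0 1)^12*(u 1 0)^7*(u 2 0)
    + (-1536)*m^11*(u 0 1)^12*(u 1 0)^7*(u 0 2)
    + (-256)*m^11*(u 0 1)^13*(u 1 0)^5*(u 1 1)*(u 1 2) + 128*m^11*(u 0 1)^13*(u 1 0)^5*(u 1 1)^2
    + (-128)*m^11*(u 0 1)^13*(u 1 0)^6*(u 1 2) + 960*m^11*(u 0 1)^13*(u 1 0)^6*(u 1 1)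
    + 192*m^11*(u 0 1)^13*(u 1 0)^7 + (-256)*x*m^11*(u 0 1)^7*(u 1 0)^11*(u 0 2)*(u 1 1)
    + 128*x*m^11*(u 0 1)^7*(u 1 0)^12*(u 0 2) + (-512)*x*m^11*(u 0 1)^8*(u 1 0)^10*(u 1 1)^2
    + 256*x*m^11*(u 0 1)^8*(u 1 0)^10*(u 0 2)*(u 2 0)
    + (-512)*x*m^11*(u 0 1)^8*(u 1 0)^10*(u 0 2)^2 + (-256)*x*m^11*(u 0 1)^8*(u 1 0)^11*(u 1 2)
    + 384*x*m^11*(u 0 1)^8*(u 1 0)^11*(u 1 1) + 3584*x*m^11*(u 0 1)^9*(u 1 0)^9*(u 0 2)*(u 1 1)
    + 256*x*m^11*(u 0 1)^9*(u 1 0)^10*(u 2 0) + (-1664)*x*m^11*(u 0 1)^9*(u 1 0)^10*(u 0 2)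
    + (-1024)*x*m^11*(u 0 1)^10*(u 1 0)^8*(u 1 1)^2
    + (-3584)*x*m^11*(u 0 1)^10*(u 1 0)^8*(u 0 2)*(u 2 0)
    + 4608*x*m^11*(u 0 1)^10*(u 1 0)^8*(u 0 2)^2 + (-768)*x*m^11*(u 0 1)^10*(u 1 0)^9*(u 1 2)
    + 1152*x*m^11*(u 0 1)^10*(u 1 0)^9*(u 1 1) + 512*x*m^11*(u 0 1)^10*(u 1 0)^10
    + 6144*x*m^11*(u 0 1)^11*(u 1 0)^7*(u 1 1)*(u 2 0)
    + (-9472)*x*m^11*(u 0 1)^11*(u 1 0)^7*(u 0 2)*(u 1 1)
    + 512*x*m^11*(u 0 1)^11*(u 1 0)^8*(u 2 0) + (-3712)*x*m^11*(u 0 1)^11*(u 1 0)^8*(u 0 2)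
    + 11776*x*m^11*(u 0 1)^12*(u 1 0)^6*(u 1 1)^2
    + (-768)*x*m^11*(u 0 1)^12*(u 1 0)^6*(u 0 2)*(u 2 0)
    + 2048*x*m^11*(u 0 1)^12*(u 1 0)^6*(u 0 2)^2 + (-768)*x*m^11*(u 0 1)^12*(u 1 0)^7*(u 1 2)
    + 1152*x*m^11*(u 0 1)^12*(u 1 0)^7*(u 1 1) + 1024*x*m^11*(u 0 1)^12*(u 1 0)^8
    + (-1024)*x*m^11*(u 0 1)^13*(u 1 0)^5*(u 0 2)*(u 1 1)
    + 256*x*m^11*(u 0 1)^13*(u 1 0)^6*(u 2 0) + (-1920)*x*m^11*(u 0 1)^13*(u 1 0)^6*(u 0 2)
    + (-256)*x*m^11*(u 0 1)^14*(u 1 0)^5*(u 1 2) + 384*x*m^11*(u 0 1)^14*(u 1 0)^5*(u 1 1)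
    + 512*x*m^11*(u 0 1)^14*(u 1 0)^6 + 256*x^2*m^11*(u 0 1)^8*(u 1 0)^11*(u 0 2)
    + (-2048)*x^2*m^11*(u 0 1)^9*(u 1 0)^10*(u 1 1) + 1280*x^2*m^11*(u 0 1)^9*(u 1 0)^11
    + 2048*x^2*m^11*(u 0 1)^10*(u 1 0)^9*(u 2 0) + (-5376)*x^2*m^11*(u 0 1)^10*(u 1 0)^9*(u 0 2)
    + 6144*x^2*m^11*(u 0 1)^11*(u 1 0)^8*(u 1 1) + 2816*x^2*m^11*(u 0 1)^11*(u 1 0)^9
    + 2048*x^2*m^11*(u 0 1)^12*(u 1 0)^7*(u 2 0) + (-6400)*x^2*m^11*(u 0 1)^12*(u 1 0)^7*(u 0 2)
    + 8192*x^2*m^11*(u 0 1)^13*(u 1 0)^6*(u 1 1) + 1792*x^2*m^11*(u 0 1)^13*(u 1 0)^7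
    + (-768)*x^2*m^11*(u 0 1)^14*(u 1 0)^5*(u 0 2) + 256*x^2*m^11*(u 0 1)^15*(u 1 0)^5
    + 2048*x^3*m^11*(u 0 1)^10*(u 1 0)^10 + 4096*x^3*m^11*(u 0 1)^12*(u 1 0)^8
    + 2048*x^3*m^11*(u 0 1)^14*(u 1 0)^6.

Definition elim11 :=
  (-512) * m ^ 12 * (u 1 0) ^ 7 * (u 0 1) ^ 10 * ((u 1 0) ^ 2 + (u 0 1) ^ 2) ^ 2
  * (u 1 0 + 2 * x * u 0 1).

Lemma elim1_step :
  elim1 = (m*(u 0 1)) * jac_f_xx - (2*m*(u 0 1)*(u 1 0)) * jac_g_x.
Proof. unfold elim1, jac_f_xx, jac_g_x. ring. Qed.

Lemma elim2_step :
  elim2 = (m*(u 0 1)) * elim1 - (2*m^2*(u 0 1)^3) * jac_g_y.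
Proof. unfold elim2, elim1, jac_g_y. ring. Qed.

Lemma elim3_step :
  elim3 = (2*m*(u 0 1)*(u 1 0)) * elim2 - ((-2)*m^3*(u 0 1)^3*(u 1 0)) * jac_f_yy.
Proof. unfold elim3, elim2, jac_f_yy. ring. Qed.

Lemma elim4_step :
  elim4 = (2*m*(u 0 1)*(u 1 0)) * jac_g - (m*(u 0 1)) * jac_f_x.
Proof. unfold elim4, jac_g, jac_f_x. ring. Qed.

Lemma elim5_step :
  elim5 = (2*m*(u 0 1)*(u 1 0)) * elim4 - ((-2)*m^2*(u 0 1)^3) * jac_f_y.
Proof. unfold elim5, elim4, jac_f_y. ring. Qed.

Lemma elim6_step :
  elim6 = (2*m*(u 0 1)*(u 1 0)) * elim3 - ((-4)*m^4*(u 0 1)^3*(u 1 0)^2*(u 1 1)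
    + 2*m^4*(u 0 1)^3*(u 1 0)^3 + 12*m^4*(u 0 1)^4*(u 1 0)*(u 2 0)
    + (-8)*m^4*(u 0 1)^4*(u 1 0)*(u 0 2) + 6*m^4*(u 0 1)^5*(u 1 0)
    + 8*x*m^4*(u 0 1)^4*(u 1 0)^2) * jac_f_x.
Proof. unfold elim6, elim3, jac_f_x. ring. Qed.

Lemma elim7_step :
  elim7 = (2*m*(u 0 1)*(u 1 0)) * elim6 - ((-8)*m^5*(u 0 1)^3*(u 1 0)^4*(u 1 1)
    + 4*m^5*(u 0 1)^3*(u 1 0)^5 + 8*m^5*(u 0 1)^4*(u 1 0)^3*(u 2 0)
    + (-8)*m^5*(u 0 1)^4*(u 1 0)^3*(u 0 2) + 80*m^5*(u 0 1)^5*(u 1 0)^2*(u 1 1)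
    + (-16)*m^5*(u 0 1)^5*(u 1 0)^3 + (-24)*m^5*(u 0 1)^6*(u 1 0)*(u 2 0)
    + 16*m^5*(u 0 1)^6*(u 1 0)*(u 0 2) + (-12)*m^5*(u 0 1)^7*(u 1 0)
    + 8*x*m^5*(u 0 1)^4*(u 1 0)^4 + 24*x*m^5*(u 0 1)^6*(u 1 0)^2) * jac_f_y.
Proof. unfold elim7, elim6, jac_f_y. ring. Qed.

Lemma elim8_step :
  elim8 = ((-4)*m^3*(u 0 1)^2*(u 1 0)^3
    + (-4)*m^3*(u 0 1)^4*(u 1 0)) * elim7 - ((-16)*m^6*(u 0 1)^4*(u 1 0)^5*(u 1 1)
    + 8*m^6*(u 0 1)^4*(u 1 0)^6 + 48*m^6*(u 0 1)^5*(u 1 0)^4*(u 2 0)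
    + (-64)*m^6*(u 0 1)^5*(u 1 0)^4*(u 0 2) + 176*m^6*(u 0 1)^6*(u 1 0)^3*(u 1 1)
    + (-16)*m^6*(u 0 1)^6*(u 1 0)^4 + (-48)*m^6*(u 0 1)^7*(u 1 0)^2*(u 2 0)
    + 32*m^6*(u 0 1)^7*(u 1 0)^2*(u 0 2) + (-24)*m^6*(u 0 1)^8*(u 1 0)^2
    + 64*x*m^6*(u 0 1)^5*(u 1 0)^5 + 64*x*m^6*(u 0 1)^7*(u 1 0)^3) * elim5.
Proof. unfold elim8, elim7, elim5. ring. Qed.

Lemma elim9_step :
  elim9 = (2*m*(u 0 1)*(u 1 0)) * elim8 - (384*m^9*(u 0 1)^8*(u 1 0)^5*(u 2 0)^2) * jac_f.
Proof. unfold elim9, elim8, jac_f. ring. Qed.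

Lemma elim10_step :
  elim10 = (2*m*(u 0 1)*(u 1 0)) * elim9 - (128*m^10*(u 0 1)^7*(u 1 0)^8*(u 0 2)*(u 2 0)
    + (-128)*m^10*(u 0 1)^8*(u 1 0)^7*(u 1 1)*(u 2 0) + 128*m^10*(u 0 1)^8*(u 1 0)^8*(u 2 0)
    + (-1408)*m^10*(u 0 1)^9*(u 1 0)^6*(u 0 2)*(u 2 0)
    + (-128)*m^10*(u 0 1)^10*(u 1 0)^5*(u 1 1)*(u 2 0) + 896*m^10*(u 0 1)^10*(u 1 0)^6*(u 2 0)
    + 1536*x*m^10*(u 0 1)^9*(u 1 0)^7*(u 2 0)) * jac_f.
Proof. unfold elim10, elim9, jac_f. ring. Qed.

Lemma elim11_step :
  elim11 = (2*m*(u 0 1)*(u 1 0)) * elim10 - ((-512)*m^11*(u 0 1)^8*(u 1 0)^9*(u 1 1)^2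
    + (-256)*m^11*(u 0 1)^8*(u 1 0)^9*(u 0 2)^2 + (-256)*m^11*(u 0 1)^8*(u 1 0)^10*(u 1 2)
    + 640*m^11*(u 0 1)^8*(u 1 0)^10*(u 1 1) + (-128)*m^11*(u 0 1)^8*(u 1 0)^11
    + (-256)*m^11*(u 0 1)^9*(u 1 0)^8*(u 0 2)*(u 1 1) + 256*m^11*(u 0 1)^9*(u 1 0)^9*(u 0 2)
    + 5632*m^11*(u 0 1)^10*(u 1 0)^7*(u 1 1)^2 + 1280*m^11*(u 0 1)^10*(u 1 0)^7*(u 0 2)^2
    + (-512)*m^11*(u 0 1)^10*(u 1 0)^8*(u 1 2) + (-2304)*m^11*(u 0 1)^10*(u 1 0)^8*(u 1 1)
    + 768*m^11*(u 0 1)^10*(u 1 0)^9 + (-256)*m^11*(u 0 1)^11*(u 1 0)^6*(u 0 2)*(u 1 1)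
    + (-1280)*m^11*(u 0 1)^11*(u 1 0)^7*(u 0 2) + (-256)*m^11*(u 0 1)^12*(u 1 0)^6*(u 1 2)
    + 128*m^11*(u 0 1)^12*(u 1 0)^6*(u 1 1) + 896*m^11*(u 0 1)^12*(u 1 0)^7
    + 256*x*m^11*(u 0 1)^8*(u 1 0)^10*(u 0 2) + 256*x*m^11*(u 0 1)^9*(u 1 0)^10
    + (-3584)*x*m^11*(u 0 1)^10*(u 1 0)^8*(u 0 2) + 6144*x*m^11*(u 0 1)^11*(u 1 0)^7*(u 1 1)
    + 512*x*m^11*(u 0 1)^11*(u 1 0)^8 + (-768)*x*m^11*(u 0 1)^12*(u 1 0)^6*(u 0 2)
    + 256*x*m^11*(u 0 1)^13*(u 1 0)^6 + 2048*x^2*m^11*(u 0 1)^10*(u 1 0)^9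
    + 2048*x^2*m^11*(u 0 1)^12*(u 1 0)^7) * jac_f.
Proof. unfold elim11, elim10, jac_f. ring. Qed.

Lemma elim11_of_jacobians :
  jac_f = 0 -> jac_f_x = 0 -> jac_f_y = 0 -> jac_f_xx = 0 -> jac_f_yy = 0 ->
  jac_g = 0 -> jac_g_x = 0 -> jac_g_y = 0 -> elim11 = 0.
Proof.
  intros Hf Hfx Hfy Hfxx Hfyy Hg Hgx Hgy.
  assert (H1 : elim1 = 0) by (rewrite elim1_step, Hfxx, Hgx; ring).
  assert (H2 : elim2 = 0) by (rewrite elim2_step, H1, Hgy; ring).
  assert (H3 : elim3 = 0) by (rewrite elim3_step, H2, Hfyy; ring).
  assert (H4 : elim4 = 0) by (rewrite elim4_step, Hg, Hfx; ring).
  assert (H5 : elim5 = 0) by (rewrite elim5_step, H4, Hfy; ring).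
  assert (H6 : elim6 = 0) by (rewrite elim6_step, H3, Hfx; ring).
  assert (H7 : elim7 = 0) by (rewrite elim7_step, H6, Hfy; ring).
  assert (H8 : elim8 = 0) by (rewrite elim8_step, H7, H5; ring).
  assert (H9 : elim9 = 0) by (rewrite elim9_step, H8, Hf; ring).
  assert (H10 : elim10 = 0) by (rewrite elim10_step, H9, Hf; ring).
  rewrite elim11_step, H10, Hf. ring.
Qed.

Lemma characteristic_of_jacobians :
  jac_f = 0 -> jac_f_x = 0 -> jac_f_y = 0 -> jac_f_xx = 0 -> jac_f_yy = 0 ->
  jac_g = 0 -> jac_g_x = 0 -> jac_g_y = 0 ->
  u 1 0 <> 0 -> u 0 1 <> 0 -> u 1 0 + 2 * x * u 0 1 = 0.
Proof.
  intros Hf Hfx Hfy Hfxx Hfyy Hg Hgx Hgy H10 H01.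
  pose proof (elim11_of_jacobians Hf Hfx Hfy Hfxx Hfyy Hg Hgx Hgy) as H. unfold elim11 in H.
  assert (Hm : 0 < m) by apply exp_pos.
  assert (Hs : 0 < (u 1 0) ^ 2 + (u 0 1) ^ 2)
    by (pose proof (pow2_ge_0 (u 0 1)); pose proof (pow2_gt_0 _ H10); lra).
  destruct (Req_dec (u 1 0 + 2 * x * u 0 1) 0) as [Z|Z]; [exact Z|].
  exfalso. revert H.
  repeat apply Rmult_integral_contrapositive_currified; try apply pow_nonzero; lra.
Qed.

(* On the characteristic [I_x + 2 x I_y = 0], together with its derivatives, [jac_f]
   reduces to [8 x mu I_y^3]. *)

Lemma jac_f_on_characteristic :
  jac_f = 0 -> u 1 0 + 2 * x * u 0 1 = 0 ->
  u 2 0 + 2 * u 0 1 + 2 * x * u 1 1 = 0 -> u 1 1 + 2 * x * u 0 2 = 0 ->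
  x * m * (u 0 1) ^ 3 = 0.
Proof.
  intros H R1 R2 R3.
  assert (E1 : u 1 0 = -2 * x * u 0 1) by lra.
  assert (E2 : u 2 0 = -2 * u 0 1 - 2 * x * u 1 1) by lra.
  assert (E3 : u 1 1 = -2 * x * u 0 2) by lra.
  unfold jac_f in H. rewrite E2 in H. rewrite E1, E3 in H.
  apply (Rmult_eq_reg_l 8); [rewrite Rmult_0_r, <- H; ring | lra].
Qed.

Lemma jac_f_of_x_flat : jac_f = 0 -> u 1 0 = 0 -> u 1 1 = 0 -> x * m * (u 0 1) ^ 3 = 0.
Proof.
  intros H R1 R2. unfold jac_f in H. rewrite R1, R2 in H.
  apply (Rmult_eq_reg_l 2); [rewrite Rmult_0_r, <- H; ring | lra].
Qed.

End Certificate.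

Definition jac_expr (e : dexpr) :=
  DAdd (DMul (DJ 0 1) (dexpr_dx e)) (DMul (DC (-1)) (DMul (DJ 1 0) (dexpr_dy e))).

Definition char_expr := DAdd (DJ 1 0) (DMul (DMul (DC 2) DX) (DJ 0 1)).

Section JacobianExpressions.
Variables (I : R * R -> R) (q : R * R).
Let ev e := dexpr_eval I e q.

Lemma eval_jac_f : ev (jac_expr grad_expr) = jac_f I q.
Proof. unfold ev, jac_f, jac_expr, grad_expr. cbn [dexpr_eval dexpr_dx dexpr_dy]. ring. Qed.

Lemma eval_jac_f_x : ev (dexpr_dx (jac_expr grad_expr)) = jac_f_x I q.
Proof. unfold ev, jac_f_x, jac_expr, grad_expr. cbn [dexpr_eval dexpr_dx dexpr_dy]. ring. Qed.

Lemma eval_jac_f_y : ev (dexpr_dy (jac_expr grad_expr)) = jac_f_y I q.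
Proof. unfold ev, jac_f_y, jac_expr, grad_expr. cbn [dexpr_eval dexpr_dx dexpr_dy]. ring. Qed.

Lemma eval_jac_f_xx : ev (dexpr_dx (dexpr_dx (jac_expr grad_expr))) = jac_f_xx I q.
Proof. unfold ev, jac_f_xx, jac_expr, grad_expr. cbn [dexpr_eval dexpr_dx dexpr_dy]. ring. Qed.

Lemma eval_jac_f_yy : ev (dexpr_dy (dexpr_dy (jac_expr grad_expr))) = jac_f_yy I q.
Proof. unfold ev, jac_f_yy, jac_expr, grad_expr. cbn [dexpr_eval dexpr_dx dexpr_dy]. ring. Qed.

Lemma eval_jac_g : ev (jac_expr lap_expr) = jac_g I q.
Proof. unfold ev, jac_g, jac_expr, lap_expr. cbn [dexpr_eval dexpr_dx dexpr_dy]. ring. Qed.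

Lemma eval_jac_g_x : ev (dexpr_dx (jac_expr lap_expr)) = jac_g_x I q.
Proof. unfold ev, jac_g_x, jac_expr, lap_expr. cbn [dexpr_eval dexpr_dx dexpr_dy]. ring. Qed.

Lemma eval_jac_g_y : ev (dexpr_dy (jac_expr lap_expr)) = jac_g_y I q.
Proof. unfold ev, jac_g_y, jac_expr, lap_expr. cbn [dexpr_eval dexpr_dx dexpr_dy]. ring. Qed.

Lemma eval_char_dx :
  ev (dexpr_dx char_expr) = pderiv I 2 0 q + 2 * pderiv I 0 1 q + 2 * fst q * pderiv I 1 1 q.
Proof. unfold ev, char_expr. cbn [dexpr_eval dexpr_dx]. ring. Qed.

Lemma eval_char_dy : ev (dexpr_dy char_expr) = pderiv I 1 1 q + 2 * fst q * pderiv I 0 2 q.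
Proof. unfold ev, char_expr. cbn [dexpr_eval dexpr_dy]. ring. Qed.

End JacobianExpressions.

Lemma continuous_nonzero_box (F : R * R -> R) (p : R * R) :
  continuous F p -> F p <> 0 -> exists r, 0 < r /\ forall q, in_box p r q -> F q <> 0.
Proof.
  intros HC Hne.
  destruct (proj1 (continuous_box_iff _ _) HC (Rabs (F p)) (Rabs_pos_lt _ Hne)) as [d [Hd H]].
  exists d. split; [exact Hd|]. intros q [H1 H2] E. specialize (H q H1 H2).
  rewrite E, Rminus_0_l, Rabs_Ropp in H. lra.
Qed.

Lemma in_box_mono p r r' q : r <= r' -> in_box p r q -> in_box p r' q.
Proof. intros H [H1 H2]. split; lra. Qed.

Lemma box_not_in_axis p r : 0 < r -> ~ (forall q, in_box p r q -> fst q = 0).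
Proof.
  intros Hr H.
  assert (Hq : in_box p r (fst p + r / 2, snd p)).
  { split; cbn; [replace (fst p + r / 2 - fst p) with (r / 2) by ring; rewrite Rabs_pos_eq
                | rewrite Rminus_diag, Rabs_R0]; lra. }
  pose proof (H p (in_box_center p r Hr)). pose proof (H _ Hq). cbn in *. lra.
Qed.

Section AnalyticLevelSets.
Variable I : R * R -> R.
Hypothesis HA : real_analytic2 I.

Definition vanishes_on_box (e : dexpr) p r := forall q, in_box p r q -> dexpr_eval I e q = 0.

Lemma vanishes_on_box_dx e p r : vanishes_on_box e p r -> vanishes_on_box (dexpr_dx e) p r.
Proof.
  intros HZ q Hq. destruct (in_box_open _ _ _ Hq) as [d [Hd Hd']].
  pose proof (is_derive_unique _ _ _ (is_derive_dexpr_x I HA e q)) as E. rewrite <- E.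
  rewrite (Derive_ext_loc _ (fun _ => 0)); [apply Derive_const|].
  exists (mkposreal d Hd). intros t Ht. apply HZ, Hd'.
  split; [exact Ht | cbn; rewrite Rminus_diag, Rabs_R0; lra].
Qed.

Lemma vanishes_on_box_dy e p r : vanishes_on_box e p r -> vanishes_on_box (dexpr_dy e) p r.
Proof.
  intros HZ q Hq. destruct (in_box_open _ _ _ Hq) as [d [Hd Hd']].
  pose proof (is_derive_unique _ _ _ (is_derive_dexpr_y I HA e q)) as E. rewrite <- E.
  rewrite (Derive_ext_loc _ (fun _ => 0)); [apply Derive_const|].
  exists (mkposreal d Hd). intros t Ht. apply HZ, Hd'.
  split; [cbn; rewrite Rminus_diag, Rabs_R0; lra | exact Ht].
Qed.

Lemma jacobian_vanishes_of_level_const e :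
  (forall p q, same_level_component I p q -> dexpr_eval I e p = dexpr_eval I e q) ->
  forall p, pderiv I 0 1 p <> 0 -> dexpr_eval I (jac_expr e) p = 0.
Proof.
  intros Hs [x0 y0] Hne.
  assert (E := level_jacobian I (pderiv I 1 0) (pderiv I 0 1) (dexpr_eval I e)
    (dexpr_eval I (dexpr_dx e)) (dexpr_eval I (dexpr_dy e)) x0 y0
    (is_derive_pderiv_x I HA 0 0) (is_derive_pderiv_y I HA 0 0)
    (is_derive_dexpr_x I HA e) (is_derive_dexpr_y I HA e)
    (continuous_pderiv I HA 0 0) (continuous_pderiv I HA 1 0) (continuous_pderiv I HA 0 1)
    (continuous_dexpr_eval I HA (dexpr_dx e)) (continuous_dexpr_eval I HA (dexpr_dy e))
    (fun q Hq => eq_sym (Hs _ _ Hq)) Hne).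
  unfold jac_expr. cbn [dexpr_eval]. rewrite <- E. ring.
Qed.

Lemma no_box_with_x_factor p r : 0 < r ->
  (forall q, in_box p r q -> pderiv I 0 1 q <> 0 /\ fst q * mu q * pderiv I 0 1 q ^ 3 = 0) ->
  False.
Proof.
  intros Hr H. apply (box_not_in_axis p r Hr). intros q Hq.
  destruct (H q Hq) as [Hu E]. pose proof (exp_pos (fst q ^ 2 - snd q)).
  apply Rmult_integral in E as [E|E].
  - apply Rmult_integral in E as [E|E]; [exact E | unfold mu in E; lra].
  - exfalso. exact (pow_nonzero _ 3 Hu E).
Qed.

Lemma constant_of_gradient_zero :
  (forall p, pderiv I 1 0 p = 0 /\ pderiv I 0 1 p = 0) -> forall p, I p = I (0, 0).
Proof.
  intros H [x y].
  destruct (MVT_is_derive (fun s => I (s, y)) (fun s => pderiv I 1 0 (s, y)) 0 x) as [c [_ E1]].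
  { intros s _. exact (is_derive_pderiv_x I HA 0 0 (s, y)). }
  destruct (MVT_is_derive (fun s => I (0, s)) (fun s => pderiv I 0 1 (0, s)) 0 y) as [d [_ E2]].
  { intros s _. exact (is_derive_pderiv_y I HA 0 0 (0, s)). }
  rewrite (proj1 (H (c, y))) in E1. rewrite (proj2 (H (0, d))) in E2. lra.
Qed.

Hypothesis Hlev : forall p q, same_level_component I p q ->
  grad_norm2 conf_factor zero_fun conf_factor I p =
  grad_norm2 conf_factor zero_fun conf_factor I q /\
  laplace_beltrami conf_factor zero_fun conf_factor I p =
  laplace_beltrami conf_factor zero_fun conf_factor I q.

Lemma grad_expr_level_const p q :
  same_level_component I p q -> dexpr_eval I grad_expr p = dexpr_eval I grad_expr q.
Proof. intro H. rewrite <- !grad_norm2_conf. exact (proj1 (Hlev p q H)). Qed.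

Lemma lap_expr_level_const p q :
  same_level_component I p q -> dexpr_eval I lap_expr p = dexpr_eval I lap_expr q.
Proof. intro H. rewrite <- !laplace_beltrami_conf. exact (proj2 (Hlev p q H)). Qed.


Lemma partials_not_both_nonzero p : pderiv I 1 0 p <> 0 -> pderiv I 0 1 p <> 0 -> False.
Proof.
  intros H1 H2.
  destruct (continuous_nonzero_box _ p (continuous_pderiv I HA 1 0 p) H1) as [r1 [Hr1 B1]].
  destruct (continuous_nonzero_box _ p (continuous_pderiv I HA 0 1 p) H2) as [r2 [Hr2 B2]].
  set (r := Rmin r1 r2).
  assert (Hb1 : forall q, in_box p r q -> pderiv I 1 0 q <> 0)
    by (intros q Hq; apply B1; eapply in_box_mono; [apply Rmin_l | eauto]).
  assert (Hb2 : forall q, in_box p r q -> pderiv I 0 1 q <> 0)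
    by (intros q Hq; apply B2; eapply in_box_mono; [apply Rmin_r | eauto]).
  assert (Zf : vanishes_on_box (jac_expr grad_expr) p r)
    by (intros q Hq; apply jacobian_vanishes_of_level_const; auto; apply grad_expr_level_const).
  assert (Zg : vanishes_on_box (jac_expr lap_expr) p r)
    by (intros q Hq; apply jacobian_vanishes_of_level_const; auto; apply lap_expr_level_const).
  assert (Zc : vanishes_on_box char_expr p r).
  { intros q Hq. apply characteristic_of_jacobians; auto.
    - rewrite <- eval_jac_f. exact (Zf q Hq).
    - rewrite <- eval_jac_f_x. exact (vanishes_on_box_dx _ _ _ Zf q Hq).
    - rewrite <- eval_jac_f_y. exact (vanishes_on_box_dy _ _ _ Zf q Hq).
    - rewrite <- eval_jac_f_xx. exact (vanishes_on_box_dx _ _ _ (vanishes_on_box_dx _ _ _ Zf) q Hq).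
    - rewrite <- eval_jac_f_yy. exact (vanishes_on_box_dy _ _ _ (vanishes_on_box_dy _ _ _ Zf) q Hq).
    - rewrite <- eval_jac_g. exact (Zg q Hq).
    - rewrite <- eval_jac_g_x. exact (vanishes_on_box_dx _ _ _ Zg q Hq).
    - rewrite <- eval_jac_g_y. exact (vanishes_on_box_dy _ _ _ Zg q Hq). }
  apply (no_box_with_x_factor p r ltac:(now apply Rmin_pos)). intros q Hq.
  split; [now apply Hb2|].
  apply jac_f_on_characteristic.
  - rewrite <- eval_jac_f. now apply Zf.
  - exact (Zc q Hq).
  - rewrite <- eval_char_dx. exact (vanishes_on_box_dx _ _ _ Zc q Hq).
  - rewrite <- eval_char_dy. exact (vanishes_on_box_dy _ _ _ Zc q Hq).
Qed.

Lemma Iy_nonzero_absurd p :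
  pderiv I 0 1 p <> 0 -> (forall q, pderiv I 1 0 q = 0 \/ pderiv I 0 1 q = 0) -> False.
Proof.
  intros H2 Hor.
  destruct (continuous_nonzero_box _ p (continuous_pderiv I HA 0 1 p) H2) as [r [Hr Hb2]].
  assert (Z0 : vanishes_on_box (DJ 1 0) p r).
  { intros q Hq. cbn. destruct (Hor q); auto. exfalso; now apply (Hb2 q Hq). }
  apply (no_box_with_x_factor p r Hr). intros q Hq. split; [now apply Hb2|].
  apply jac_f_of_x_flat.
  - rewrite <- eval_jac_f. apply jacobian_vanishes_of_level_const; auto.
    apply grad_expr_level_const.
  - exact (Z0 q Hq).
  - exact (vanishes_on_box_dy _ _ _ Z0 q Hq).
Qed.


Lemma Ix_nonzero_absurd p :
  pderiv I 1 0 p <> 0 -> (forall q, pderiv I 1 0 q = 0 \/ pderiv I 0 1 q = 0) -> False.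
Proof.
  intros H1 Hor. destruct p as [x0 y0].
  destruct (continuous_nonzero_box _ _ (continuous_pderiv I HA 1 0 (x0, y0)) H1) as [r [Hr Hb1]].
  assert (Z0 : vanishes_on_box (DJ 0 1) (x0, y0) r).
  { intros q Hq. cbn. destruct (Hor q); auto. exfalso; now apply (Hb1 q Hq). }
  pose proof (vanishes_on_box_dx _ _ _ Z0) as Z1.
  set (y1 := y0 + r / 2).
  assert (Hin : forall t, y0 <= t <= y1 -> in_box (x0, y0) r (x0, t)).
  { intros t Ht.
    split; cbn; [rewrite Rminus_diag, Rabs_R0 | rewrite Rabs_pos_eq]; unfold y1 in *; lra. }
  assert (Hflat : forall (F : R * R -> R) i j, (forall t, is_derive (fun s => F (x0, s)) t
             (pderiv I i j (x0, t))) -> vanishes_on_box (DJ i j) (x0, y0) r ->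
             forall t, y0 <= t <= y1 -> F (x0, t) = F (x0, y0)).
  { intros F i j HF HZ t Ht.
    destruct (MVT_is_derive (fun s => F (x0, s)) (fun s => pderiv I i j (x0, s)) y0 t)
      as [c [Hc E]]; [intros s _; apply HF|].
    rewrite Rmin_left, Rmax_right in Hc by lra.
    assert (Hz : pderiv I i j (x0, c) = 0) by (apply (HZ (x0, c)), Hin; lra).
    rewrite Hz, Rmult_0_l in E. lra. }
  assert (HI : forall t, y0 <= t <= y1 -> I (x0, t) = I (x0, y0))
    by (eapply Hflat; [intro t; exact (is_derive_pderiv_y I HA 0 0 (x0, t)) | exact Z0]).
  assert (HIx : pderiv I 1 0 (x0, y1) = pderiv I 1 0 (x0, y0)).
  { eapply Hflat; [intro t; exact (is_derive_pderiv_y I HA 1 0 (x0, t)) | exact Z1 |].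
    unfold y1; lra. }
  assert (Hcomp : same_level_component I (x0, y0) (x0, y1)).
  { apply (same_level_component_of_path I (fun t => (x0, t)) y0 y1 y0 y1);
      [| intros s Hs; now apply HI | unfold y1; lra | unfold y1; lra].
    intros s _. apply continuous_pair; [apply continuous_const | apply continuous_id]. }
  pose proof (grad_expr_level_const _ _ Hcomp) as E.
  unfold grad_expr in E. cbn [dexpr_eval] in E.
  assert (Ea : pderiv I 0 1 (x0, y0) = 0) by (apply (Z0 (x0, y0)), Hin; unfold y1; lra).
  assert (Eb : pderiv I 0 1 (x0, y1) = 0) by (apply (Z0 (x0, y1)), Hin; unfold y1; lra).
  rewrite HIx, Ea, Eb in E.
  assert (Hm : mu (x0, y0) = mu (x0, y1)).
  { apply (Rmult_eq_reg_r (pderiv I 1 0 (x0, y0) * pderiv I 1 0 (x0, y0) + 0 * 0)); [exact E|].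
    pose proof (pow2_gt_0 _ H1). cbn in *. lra. }
  unfold mu in Hm. cbn in Hm. apply exp_inv in Hm. unfold y1 in Hm. lra.
Qed.

Lemma gradient_vanishes p : pderiv I 1 0 p = 0 /\ pderiv I 0 1 p = 0.
Proof.
  assert (Hor : forall q, pderiv I 1 0 q = 0 \/ pderiv I 0 1 q = 0).
  { intro q. destruct (Req_dec (pderiv I 1 0 q) 0); [now left|].
    destruct (Req_dec (pderiv I 0 1 q) 0); [now right|].
    exfalso. now apply (partials_not_both_nonzero q). }
  destruct (Req_dec (pderiv I 0 1 p) 0) as [E2|E2]; [|exfalso; now apply (Iy_nonzero_absurd p)].
  destruct (Req_dec (pderiv I 1 0 p) 0) as [E1|E1]; [now split|].
  exfalso. now apply (Ix_nonzero_absurd p).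
Qed.

End AnalyticLevelSets.

Theorem mainTheorem6 :
  forall I : R * R -> R,
    equilibrium_function conf_factor zero_fun conf_factor I ->
    exists c : R, forall p : R * R, I p = c.
Proof.
  intros I [HA Hlev].
  exists (I (0, 0)).
  exact (constant_of_gradient_zero I HA (gradient_vanishes I HA Hlev)).
Qed.
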